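(* The calculus $\vdash^{\mathsf{Ind}}$ is sound with respect to the standard semantics $\vDash$ (for every signature $\Sigma$ and sets $\Gamma,\Delta$ of $\Sigma$-sentences, $\Gamma\vdash^{\mathsf{Ind}}_\Sigma\Delta$ implies $\Gamma\vDash_\Sigma\Delta$), it is not complete with respect to $\vDash$, and it is compact: if $\Gamma\vdash^{\mathsf{Ind}}_\Sigma\Delta$, then there exist a finite subsignature $\iota:\Sigma_f\subseteq\Sigma$ and finite sets $\Gamma_f\subseteq\iota^{-1}(\Gamma)$, $\Delta_f\subseteq\iota^{-1}(\Delta)$ of $\Sigma_f$-sentences with $\Gamma_f\vdash^{\mathsf{Ind}}_{\Sigma_f}\Delta_f$.
   Context: Syntax. A signature $\Sigma=(S,F,L)$: sorts $S$, function symbols $F=(F_{w\to s})$, labels $L=(L_s)_{s\in S}$, pairwise disjoint. $\Sigma$-terms are ground terms over $(S,F)$. Actions of sort $s$: $\mathfrak{a}::=\lambda\ (\lambda\in L_s)\mid \mathbf{0}_s\mid\mathbf{1}_s\mid \mathfrak{a}\cup\mathfrak{a}\mid\mathfrak{a}\Rightarrow\mathfrak{a}\mid\mathfrak{a};\mathfrak{a}\mid\mathfrak{a}\triangleright\mathfrak{a}\mid\mathfrak{a}^*$. A block $X$ is a finite set of fresh first-order variables (of sorts $s$) and label variables (of sorts $s$); $\Sigma[X]$ adds them as constants of sort $s$ resp. labels in $L_s$. Sentences: $t_0=t_1$, $t_0\xrightarrow{\mathfrak{a}}t_1$, $\varphi\to\psi$, $\vee\Phi$, $\wedge\Phi$ ($\Phi$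 finite sequence), $\exists X\varphi$, $\forall X\varphi$. A substitution $\theta$ for $X$ maps first-order variables of sort $s$ to $\Sigma$-terms and label variables of sort $s$ to $\Sigma$-actions of sort $s$. Standard semantics. A $\Sigma$-model $\mathfrak{A}$ is an $(S,F)$-algebra with relations $\lambda^{\mathfrak{A}}\subseteq\mathfrak{A}_s\times\mathfrak{A}_s$ ($\lambda\in L_s$). Actions denote relations: $\mathbf{0}_s\mapsto\emptyset$, $\mathbf{1}_s\mapsto$ identity, $\cup\mapsto$ union, $\mathfrak{a}_0\Rightarrow\mathfrak{a}_1\mapsto(\mathfrak{a}_0^{\mathfrak{A}})^c\cup\mathfrak{a}_1^{\mathfrak{A}}$, $;\mapsto$ composition, $\mathfrak{a}_0\triangleright\mathfrak{a}_1\mapsto(\mathfrak{a}_0^{\mathfrak{A}})^{-1};\mathfrak{a}_1^{\mathfrak{A}}$, $\mathfrak{a}^*\mapsto$ reflexive-transitive closure of $\mathfrak{a}^{\mathfrak{A}}$. $\mathfrak{A}\models t_0\xrightarrow{\mathfrak{a}}t_1$ iff $(t_0^{\mathfrak{A}},t_1^{\mathfrak{A}})\in\mathfrak{a}^{\mathfrak{A}}$, equations and connectives as usual, $\exists X$/$\forall X$ over all expansions to $\Sigma[X]$ (label variables ranging over all binary relations). $\Gamma\vDash_\Sigma\Delta$ iff no $\Sigma$-model satisfies all of $\Gamma$ and none of $\Delta$. Calculus $\vdash^{\mathsf{Ind}}$: the least family of relations $\Gamma\vdash_\Sigma\Delta$ (side sets arbitrary, united in conclusions; side sets of premises over $\Sigma[X]$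 read as $\Sigma[X]$-sentences) closed under: (Atom) $\Gamma_b,\Gamma\vdash\Delta,\Delta_b$ for sets $\Gamma_b,\Delta_b$ of basic sentences (equations and $t_0\xrightarrow{\lambda}t_1$ with $\lambda$ a label symbol) related by the least relation closed under initial sequents $\varphi,\Gamma\vdash\Delta,\varphi$, reflexivity/symmetry/transitivity/congruence of $=$, and replacement of equals in $t_0\xrightarrow{\lambda}t_1$; the action rules: $t_0\xrightarrow{\mathbf{0}_s}t_1,\Gamma\vdash\Delta$; from $t_0\xrightarrow{\mathfrak{a}_i}t_1,\Gamma_i\vdash\Delta_i$ ($i=0,1$) infer $t_0\xrightarrow{\mathfrak{a}_0\cup\mathfrak{a}_1}t_1,\Gamma_0\Gamma_1\vdash\Delta_0\Delta_1$; from $\Gamma\vdash\Delta,t_0\xrightarrow{\mathfrak{a}_i}t_1$ infer $\Gamma\vdash\Delta,t_0\xrightarrow{\mathfrak{a}_0\cup\mathfrak{a}_1}t_1$; from $\Gamma_0\vdash\Delta_0,t_0\xrightarrow{\mathfrak{a}_0}t_1$ and $t_0\xrightarrow{\mathfrak{a}_1}t_1,\Gamma_1\vdash\Delta_1$ infer $t_0\xrightarrow{\mathfrak{a}_0\Rightarrow\mathfrak{a}_1}t_1,\Gamma_0\Gamma_1\vdash\Delta_0\Delta_1$; from $t_0\xrightarrow{\mathfrak{a}_0}t_1,\Gamma\vdash\Delta,t_0\xrightarrow{\mathfrak{a}_1}t_1$ infer $\Gamma\vdash\Delta,t_0\xrightarrow{\mathfrak{a}_0\Rightarrow\mathfrak{a}_1}t_1$;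 $\mathbf{1}_s$-rules replacing $t_0=t_1$ by $t_0\xrightarrow{\mathbf{1}_s}t_1$ on either side; from $t_0\xrightarrow{\mathfrak{a}_0}x,x\xrightarrow{\mathfrak{a}_1}t_1,\Gamma\vdash_{\Sigma[x]}\Delta$ ($x$ fresh) infer $t_0\xrightarrow{\mathfrak{a}_0;\mathfrak{a}_1}t_1,\Gamma\vdash_\Sigma\Delta$; from $\Gamma\vdash\Delta,t_0\xrightarrow{\mathfrak{a}_0}t$ and $\Gamma'\vdash\Delta',t\xrightarrow{\mathfrak{a}_1}t_1$ infer $\Gamma\Gamma'\vdash\Delta\Delta',t_0\xrightarrow{\mathfrak{a}_0;\mathfrak{a}_1}t_1$; from $x\xrightarrow{\mathfrak{a}_0}t_0,x\xrightarrow{\mathfrak{a}_1}t_1,\Gamma\vdash_{\Sigma[x]}\Delta$ infer $t_0\xrightarrow{\mathfrak{a}_0\triangleright\mathfrak{a}_1}t_1,\Gamma\vdash_\Sigma\Delta$; from $\Gamma\vdash\Delta,t\xrightarrow{\mathfrak{a}_0}t_0$ and $\Gamma'\vdash\Delta',t\xrightarrow{\mathfrak{a}_1}t_1$ infer $\Gamma\Gamma'\vdash\Delta\Delta',t_0\xrightarrow{\mathfrak{a}_0\triangleright\mathfrak{a}_1}t_1$; the standard classical left/right rules for $\to$, $\vee\Phi$, $\wedge\Phi$ (with united side sets), $\exists_L$ and $\forall_R$ with a fresh block (premise over $\Sigma[X]$), $\exists_R$ and $\forall_L$ with substitution instances $\theta(\varphi)$; and the star rules: $t_0\xrightarrow{\mathfrak{a}^*}t_1,\Gamma\vdash\Delta,t_0\xrightarrow{\mathfrak{a}^*}t_1$;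 cut on sentences $t_0\xrightarrow{\mathfrak{a}^*}t_1$; from $\Gamma\vdash\Delta,t_0=t_1$ infer $\Gamma\vdash\Delta,t_0\xrightarrow{\mathfrak{a}^*}t_1$; from $\Gamma\vdash\Delta,t_0\xrightarrow{\mathfrak{a}^*}t$ and $\Gamma'\vdash\Delta',t\xrightarrow{\mathfrak{a}}t_1$, or from $\Gamma\vdash\Delta,t_0\xrightarrow{\mathfrak{a}}t$ and $\Gamma'\vdash\Delta',t\xrightarrow{\mathfrak{a}^*}t_1$, infer $\Gamma\Gamma'\vdash\Delta\Delta',t_0\xrightarrow{\mathfrak{a}^*}t_1$; for a term $t$, action $\mathfrak{t}$, fresh $X=\{x,y,z\}$: from $\Gamma_L\vdash\Delta_L,t\xrightarrow{\mathfrak{t}}t_0$, $z\xrightarrow{\mathfrak{t}}x,x\xrightarrow{\mathfrak{a}}y,\Gamma_M\vdash_{\Sigma[X]}\Delta_M,z\xrightarrow{\mathfrak{t}}y$, $t\xrightarrow{\mathfrak{t}}t_1,\Gamma_R\vdash\Delta_R$ infer $t_0\xrightarrow{\mathfrak{a}^*}t_1,\Gamma_L\Gamma_M\Gamma_R\vdash\Delta_L\Delta_M\Delta_R$; and from $\Gamma_L\vdash\Delta_L,t_1\xrightarrow{\mathfrak{t}}t$, $x\xrightarrow{\mathfrak{a}}y,y\xrightarrow{\mathfrak{t}}z,\Gamma_M\vdash_{\Sigma[X]}\Delta_M,x\xrightarrow{\mathfrak{t}}z$, $t_0\xrightarrow{\mathfrak{t}}t,\Gamma_R\vdash\Delta_R$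 infer the same conclusion. *)

From Stdlib Require Import List Relations.
Import ListNotations.

(* Sorts S, function symbols F_{w -> s}, labels L_s (families, hence pairwise
   disjoint by construction). *)
Record sig : Type := Sig {
  srt : Type;
  fsym : list srt -> srt -> Type;
  lab : srt -> Type }.

Inductive term (Sg : sig) : srt Sg -> Type :=
| app : forall (w : list (srt Sg)) (s : srt Sg), fsym Sg w s -> terms Sg w -> term Sg s
with terms (Sg : sig) : list (srt Sg) -> Type :=
| tnil : terms Sg []
| tcons : forall (s : srt Sg) (w : list (srt Sg)), term Sg s -> terms Sg w -> terms Sg (s :: w).
Arguments app {Sg w s} f ts.
Arguments tnil {Sg}.
Arguments tcons {Sg s w} t ts.

Inductive action (Sg : sig) : srt Sg -> Type :=
| alab : forall s, lab Sg s -> action Sg s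
| azero : forall s, action Sg s
| aone : forall s, action Sg s
| aunion : forall s, action Sg s -> action Sg s -> action Sg s
| aimp : forall s, action Sg s -> action Sg s -> action Sg s
| aseq : forall s, action Sg s -> action Sg s -> action Sg s
| arel : forall s, action Sg s -> action Sg s -> action Sg s
| astar : forall s, action Sg s -> action Sg s.
Arguments alab {Sg s} l.
Arguments azero {Sg} s.
Arguments aone {Sg} s.
Arguments aunion {Sg s} a b.
Arguments aimp {Sg s} a b.
Arguments aseq {Sg s} a b.
Arguments arel {Sg s} a b.
Arguments astar {Sg s} a.

(* A block: finitely many first-order variables and label variables, each with
   a sort; variables are the positions in the two lists. *)
Definition block (Sg : sig) : Type := (list (srt Sg) * list (srt Sg))%type.
Definition var {A : Type} (l : list A) (s : A) : Type := {i : nat | nth_error l i = Some s}.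
(* first-order variables are new constants (arity []) *)
Definition fvar {A : Type} (l : list A) (w : list A) (s : A) : Type :=
  match w with [] => var l s | _ :: _ => Empty_set end.

Definition ext (Sg : sig) (X : block Sg) : sig :=
  {| srt := srt Sg;
     fsym := fun w s => (fsym Sg w s + fvar (fst X) w s)%type;
     lab := fun s => (lab Sg s + var (snd X) s)%type |}.

Inductive sentence : sig -> Type :=
| sEq : forall Sg (s : srt Sg), term Sg s -> term Sg s -> sentence Sg
| sTr : forall Sg (s : srt Sg), action Sg s -> term Sg s -> term Sg s -> sentence Sg
| sImp : forall Sg, sentence Sg -> sentence Sg -> sentence Sg
| sOr : forall Sg, list (sentence Sg) -> sentence Sg
| sAnd : forall Sg, list (sentence Sg) -> sentence Sg
| sEx : forall Sg (X : block Sg), sentence (ext Sg X) -> sentence Sg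
| sAll : forall Sg (X : block Sg), sentence (ext Sg X) -> sentence Sg.
Arguments sEq {Sg s} t0 t1.
Arguments sTr {Sg s} a t0 t1.
Arguments sImp {Sg} phi psi.
Arguments sOr {Sg} Phi.
Arguments sAnd {Sg} Phi.
Arguments sEx {Sg} X phi.
Arguments sAll {Sg} X phi.

(* A generic translation device: sorts go to sorts, function symbols either to
   function symbols or (for the substitution of variables) to terms, labels to
   actions.  Used for signature inclusions and for substitutions theta. *)
Record mor (S1 S2 : sig) : Type := Mor {
  ms : srt S1 -> srt S2;
  mf : forall w s, fsym S1 w s -> (fsym S2 (map ms w) (ms s) + term S2 (ms s))%type;
  ml : forall s, lab S1 s -> action S2 (ms s) }.
Arguments ms {S1 S2} m s.
Arguments mf {S1 S2} m {w s} f.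
Arguments ml {S1 S2} m {s} l.

Fixpoint trt {S1 S2} (m : mor S1 S2) {s} (t : term S1 s) : term S2 (ms m s) :=
  match t with
  | app f ts => match mf m f with inl g => app g (trts m ts) | inr u => u end
  end
with trts {S1 S2} (m : mor S1 S2) {w} (ts : terms S1 w) : terms S2 (map (ms m) w) :=
  match ts with
  | tnil => tnil
  | tcons t ts => tcons (trt m t) (trts m ts)
  end.

Fixpoint tra {S1 S2} (m : mor S1 S2) {s} (a : action S1 s) : action S2 (ms m s) :=
  match a with
  | alab l => ml m l
  | azero s => azero (ms m s)
  | aone s => aone (ms m s)
  | aunion a b => aunion (tra m a) (tra m b)
  | aimp a b => aimp (tra m a) (tra m b)
  | aseq a b => aseq (tra m a) (tra m b)
  | arel a b => arel (tra m a) (tra m b)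
  | astar a => astar (tra m a)
  end.

Fixpoint embt {Sg} (Z : block Sg) {s} (t : term Sg s) : term (ext Sg Z) s :=
  match t with app f ts => @app (ext Sg Z) _ _ (inl f) (embts Z ts) end
with embts {Sg} (Z : block Sg) {w} (ts : terms Sg w) : terms (ext Sg Z) w :=
  match ts with
  | tnil => tnil
  | tcons t ts => @tcons (ext Sg Z) _ _ (embt Z t) (embts Z ts)
  end.

Fixpoint emba {Sg} (Z : block Sg) {s} (a : action Sg s) : action (ext Sg Z) s :=
  match a with
  | alab l => @alab (ext Sg Z) _ (inl l)
  | azero s => @azero (ext Sg Z) s
  | aone s => @aone (ext Sg Z) s
  | aunion a b => @aunion (ext Sg Z) _ (emba Z a) (emba Z b)
  | aimp a b => @aimp (ext Sg Z) _ (emba Z a) (emba Z b)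
  | aseq a b => @aseq (ext Sg Z) _ (emba Z a) (emba Z b)
  | arel a b => @arel (ext Sg Z) _ (emba Z a) (emba Z b)
  | astar a => @astar (ext Sg Z) _ (emba Z a)
  end.

Definition mapb {S1 S2} (f : srt S1 -> srt S2) (X : block S1) : block S2 :=
  (map f (fst X), map f (snd X)).

Definition mapvar {A B : Type} (f : A -> B) (l : list A) (s : A) (v : var l s)
  : var (map f l) (f s) :=
  exist _ (proj1_sig v) (map_nth_error f (proj1_sig v) l (proj2_sig v)).

Definition mapfvar {A B : Type} (f : A -> B) (l : list A) :
  forall w s, fvar l w s -> fvar (map f l) (map f w) (f s) :=
  fun w => match w with
           | [] => fun s v => mapvar f l s v
           | _ :: _ => fun s e => match e with end
           end.

Definition lift {S1 S2} (m : mor S1 S2) (Y : block S1) :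
  mor (ext S1 Y) (ext S2 (mapb (ms m) Y)) :=
  Mor (ext S1 Y) (ext S2 (mapb (ms m) Y)) (ms m)
     (fun w s (f : fsym (ext S1 Y) w s) =>
       match f with
       | inl g => match mf m g with
                  | inl h => inl (inl h)
                  | inr u => inr (embt (mapb (ms m) Y) u)
                  end
       | inr v => inl (inr (mapfvar (ms m) (fst Y) w s v))
       end)
     (fun s (l : lab (ext S1 Y) s) =>
       match l with
       | inl l0 => emba (mapb (ms m) Y) (ml m l0)
       | inr v => @alab (ext S2 (mapb (ms m) Y)) _ (inr (mapvar (ms m) (snd Y) s v))
       end).

Fixpoint trs {S1} (phi : sentence S1) {struct phi} : forall S2, mor S1 S2 -> sentence S2 :=
  match phi in sentence S0 return forall S2, mor S0 S2 -> sentence S2 with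
  | sEq t0 t1 => fun S2 m => sEq (trt m t0) (trt m t1)
  | sTr a t0 t1 => fun S2 m => sTr (tra m a) (trt m t0) (trt m t1)
  | sImp p q => fun S2 m => sImp (trs p S2 m) (trs q S2 m)
  | sOr Phi => fun S2 m => sOr (map (fun p => trs p S2 m) Phi)
  | sAnd Phi => fun S2 m => sAnd (map (fun p => trs p S2 m) Phi)
  | sEx X p => fun S2 m => sEx (mapb (ms m) X) (trs p _ (lift m X))
  | sAll X p => fun S2 m => sAll (mapb (ms m) X) (trs p _ (lift m X))
  end.

Definition castw {Sg : sig} {w : list (srt Sg)} {s} (f : fsym Sg w s)
  : fsym Sg (map (fun x => x) w) s :=
  eq_rect_r (fun w' => fsym Sg w' s) f (map_id w).

Definition incl (Sg : sig) (X : block Sg) : mor Sg (ext Sg X) :=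
  Mor Sg (ext Sg X) (fun s => s)
     (fun w s f => inl (inl (castw f)))
     (fun s l => @alab (ext Sg X) s (inl l)).

Record subst (Sg : sig) (X : block Sg) : Type := Subst {
  sub_f : forall s, var (fst X) s -> term Sg s;
  sub_l : forall s, var (snd X) s -> action Sg s }.
Arguments sub_f {Sg X} _ s _.
Arguments sub_l {Sg X} _ s _.

Definition subst_mor {Sg X} (th : subst Sg X) : mor (ext Sg X) Sg :=
  Mor (ext Sg X) Sg (fun s => s)
     (fun w s (f : fsym (ext Sg X) w s) =>
       match f with
       | inl g => inl (castw g)
       | inr v => inr ((match w return fvar (fst X) w s -> term Sg s with
                        | [] => fun v => sub_f th s v
                        | _ :: _ => fun e => match e with end
                        end) v)
       end)
     (fun s (l : lab (ext Sg X) s) =>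
       match l with inl l0 => alab l0 | inr v => sub_l th s v end).

Definition inst {Sg X} (th : subst Sg X) (phi : sentence (ext Sg X)) : sentence Sg :=
  trs phi Sg (subst_mor th).

Fixpoint tuple {S : Type} (A : S -> Type) (w : list S) : Type :=
  match w with [] => unit | s :: w => (A s * tuple A w)%type end.

Record model (Sg : sig) : Type := Model {
  car : srt Sg -> Type;
  mfun : forall w s, fsym Sg w s -> tuple car w -> car s;
  mlab : forall s, lab Sg s -> car s -> car s -> Prop }.
Arguments car {Sg} _ s.
Arguments mfun {Sg} _ {w s} _ _.
Arguments mlab {Sg} _ {s} _ _ _.

Fixpoint evt {Sg} (M : model Sg) {s} (t : term Sg s) : car M s :=
  match t with app f ts => mfun M f (evts M ts) end
with evts {Sg} (M : model Sg) {w} (ts : terms Sg w) : tuple (car M) w :=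
  match ts with
  | tnil => tt
  | tcons t ts => (evt M t, evts M ts)
  end.

Fixpoint aden {Sg} (M : model Sg) {s} (a : action Sg s) : car M s -> car M s -> Prop :=
  match a with
  | alab l => mlab M l
  | azero _ => fun _ _ => False
  | aone _ => fun x y => x = y
  | aunion a b => fun x y => aden M a x y \/ aden M b x y
  | aimp a b => fun x y => ~ aden M a x y \/ aden M b x y
  | aseq a b => fun x z => exists y, aden M a x y /\ aden M b y z
  | arel a b => fun x y => exists z, aden M a z x /\ aden M b z y
  | astar a => clos_refl_trans _ (aden M a)
  end.

Definition expand {Sg} (M : model Sg) (X : block Sg)
  (v : forall s, var (fst X) s -> car M s)
  (r : forall s, var (snd X) s -> car M s -> car M s -> Prop) : model (ext Sg X) :=
  Model (ext Sg X) (car M)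
     (fun w s (f : fsym (ext Sg X) w s) =>
       match f with
       | inl g => mfun M g
       | inr u => (match w return fvar (fst X) w s -> tuple (car M) w -> car M s with
                   | [] => fun u _ => v s u
                   | _ :: _ => fun e => match e with end
                   end) u
       end)
     (fun s (l : lab (ext Sg X) s) =>
       match l with inl l0 => mlab M l0 | inr u => r s u end).

Fixpoint sat {Sg} (phi : sentence Sg) {struct phi} : model Sg -> Prop :=
  match phi in sentence S0 return model S0 -> Prop with
  | sEq t0 t1 => fun M => evt M t0 = evt M t1
  | sTr a t0 t1 => fun M => aden M a (evt M t0) (evt M t1)
  | sImp p q => fun M => sat p M -> sat q M
  | sOr Phi => fun M => (fix go l := match l with [] => False | p :: l => sat p M \/ go l end) Phi
  | sAnd Phi => fun M => (fix go l := match l with [] => True | p :: l => sat p M /\ go l end) Phi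
  | sEx X p => fun M => exists v r, sat p (expand M X v r)
  | sAll X p => fun M => forall v r, sat p (expand M X v r)
  end.

Definition sset (Sg : sig) : Type := sentence Sg -> Prop.

Definition valid (Sg : sig) (G D : sset Sg) : Prop :=
  forall M : model Sg, (forall phi, G phi -> sat phi M) -> exists psi, D psi /\ sat psi M.

Definition add {Sg} (phi : sentence Sg) (G : sset Sg) : sset Sg := fun psi => psi = phi \/ G psi.
Definition cup {Sg} (G1 G2 : sset Sg) : sset Sg := fun psi => G1 psi \/ G2 psi.
Definition bigcup {Sg} (Phi : list (sentence Sg)) (F : nat -> sset Sg) : sset Sg :=
  fun psi => exists i phi, nth_error Phi i = Some phi /\ F i psi.
Definition up {Sg} (X : block Sg) (G : sset Sg) : sset (ext Sg X) :=
  fun psi => exists phi, G phi /\ psi = trs phi _ (incl Sg X).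

Definition E {Sg} (X : block Sg) {s} (t : term Sg s) : term (ext Sg X) s := trt (incl Sg X) t.
Definition EA {Sg} (X : block Sg) {s} (a : action Sg s) : action (ext Sg X) s := tra (incl Sg X) a.
Definition vt {Sg} (X : block Sg) {s} (v : var (fst X) s) : term (ext Sg X) s :=
  @app (ext Sg X) [] s (inr v) tnil.

Definition b1 {Sg} (s : srt Sg) : block Sg := ([s], []).
Definition b3 {Sg} (s : srt Sg) : block Sg := ([s; s; s], []).
Definition vx1 {Sg} (s : srt Sg) : term (ext Sg (b1 s)) s := vt (b1 s) (exist _ 0 eq_refl).
Definition vx {Sg} (s : srt Sg) : term (ext Sg (b3 s)) s := vt (b3 s) (exist _ 0 eq_refl).
Definition vy {Sg} (s : srt Sg) : term (ext Sg (b3 s)) s := vt (b3 s) (exist _ 1 eq_refl).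
Definition vz {Sg} (s : srt Sg) : term (ext Sg (b3 s)) s := vt (b3 s) (exist _ 2 eq_refl).

Definition basic {Sg} (phi : sentence Sg) : Prop :=
  match phi with
  | sEq _ _ => True
  | sTr a _ _ => match a with alab _ => True | _ => False end
  | _ => False
  end.
Definition basicset {Sg} (G : sset Sg) : Prop := forall phi, G phi -> basic phi.

Inductive argpair (Sg : sig) : forall w, terms Sg w -> terms Sg w ->
                                forall s, term Sg s -> term Sg s -> Prop :=
| ap_here : forall s w (t t' : term Sg s) (ts ts' : terms Sg w),
    argpair Sg (s :: w) (tcons t ts) (tcons t' ts') s t t'
| ap_there : forall s w (t t' : term Sg s) (ts ts' : terms Sg w) s' (u u' : term Sg s'),
    argpair Sg w ts ts' s' u u' -> argpair Sg (s :: w) (tcons t ts) (tcons t' ts') s' u u'.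

Inductive bderiv (Sg : sig) : sset Sg -> sset Sg -> Prop :=
| b_init : forall phi G D, bderiv Sg (add phi G) (add phi D)
| b_refl : forall s (t : term Sg s) G D, bderiv Sg G (add (sEq t t) D)
| b_sym : forall s (t t' : term Sg s) G D,
    bderiv Sg G (add (sEq t t') D) -> bderiv Sg G (add (sEq t' t) D)
| b_trans : forall s (t1 t2 t3 : term Sg s) G D,
    bderiv Sg G (add (sEq t1 t2) D) -> bderiv Sg G (add (sEq t2 t3) D) ->
    bderiv Sg G (add (sEq t1 t3) D)
| b_cong : forall w s (f : fsym Sg w s) (ts ts' : terms Sg w) G D,
    (forall s' (u u' : term Sg s'), argpair Sg w ts ts' s' u u' -> bderiv Sg G (add (sEq u u') D)) ->
    bderiv Sg G (add (sEq (app f ts) (app f ts')) D)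
| b_repl : forall s (l : lab Sg s) (t0 t0' t1 t1' : term Sg s) G D,
    bderiv Sg G (add (sEq t0 t0') D) -> bderiv Sg G (add (sEq t1 t1') D) ->
    bderiv Sg G (add (sTr (alab l) t0 t1) D) ->
    bderiv Sg G (add (sTr (alab l) t0' t1') D).

Inductive deriv : forall Sg : sig, sset Sg -> sset Sg -> Prop :=
| d_atom : forall Sg (Gb Db G D : sset Sg),
    basicset Gb -> basicset Db -> bderiv Sg Gb Db -> deriv Sg (cup Gb G) (cup D Db)
| d_zero : forall Sg s (t0 t1 : term Sg s) G D,
    deriv Sg (add (sTr (azero s) t0 t1) G) D
| d_unionL : forall Sg s (a0 a1 : action Sg s) t0 t1 G0 D0 G1 D1,
    deriv Sg (add (sTr a0 t0 t1) G0) D0 -> deriv Sg (add (sTr a1 t0 t1) G1) D1 ->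
    deriv Sg (add (sTr (aunion a0 a1) t0 t1) (cup G0 G1)) (cup D0 D1)
| d_unionR0 : forall Sg s (a0 a1 : action Sg s) t0 t1 G D,
    deriv Sg G (add (sTr a0 t0 t1) D) -> deriv Sg G (add (sTr (aunion a0 a1) t0 t1) D)
| d_unionR1 : forall Sg s (a0 a1 : action Sg s) t0 t1 G D,
    deriv Sg G (add (sTr a1 t0 t1) D) -> deriv Sg G (add (sTr (aunion a0 a1) t0 t1) D)
| d_aimpL : forall Sg s (a0 a1 : action Sg s) t0 t1 G0 D0 G1 D1,
    deriv Sg G0 (add (sTr a0 t0 t1) D0) -> deriv Sg (add (sTr a1 t0 t1) G1) D1 ->
    deriv Sg (add (sTr (aimp a0 a1) t0 t1) (cup G0 G1)) (cup D0 D1)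
| d_aimpR : forall Sg s (a0 a1 : action Sg s) t0 t1 G D,
    deriv Sg (add (sTr a0 t0 t1) G) (add (sTr a1 t0 t1) D) ->
    deriv Sg G (add (sTr (aimp a0 a1) t0 t1) D)
| d_oneL : forall Sg s (t0 t1 : term Sg s) G D,
    deriv Sg (add (sEq t0 t1) G) D -> deriv Sg (add (sTr (aone s) t0 t1) G) D
| d_oneR : forall Sg s (t0 t1 : term Sg s) G D,
    deriv Sg G (add (sEq t0 t1) D) -> deriv Sg G (add (sTr (aone s) t0 t1) D)
| d_seqL : forall Sg s (a0 a1 : action Sg s) t0 t1 G D,
    deriv (ext Sg (b1 s))
      (add (sTr (EA (b1 s) a0) (E (b1 s) t0) (vx1 s))
        (add (sTr (EA (b1 s) a1) (vx1 s) (E (b1 s) t1)) (up (b1 s) G)))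
      (up (b1 s) D) ->
    deriv Sg (add (sTr (aseq a0 a1) t0 t1) G) D
| d_seqR : forall Sg s (a0 a1 : action Sg s) t0 t t1 G D G' D',
    deriv Sg G (add (sTr a0 t0 t) D) -> deriv Sg G' (add (sTr a1 t t1) D') ->
    deriv Sg (cup G G') (add (sTr (aseq a0 a1) t0 t1) (cup D D'))
| d_relL : forall Sg s (a0 a1 : action Sg s) t0 t1 G D,
    deriv (ext Sg (b1 s))
      (add (sTr (EA (b1 s) a0) (vx1 s) (E (b1 s) t0))
        (add (sTr (EA (b1 s) a1) (vx1 s) (E (b1 s) t1)) (up (b1 s) G)))
      (up (b1 s) D) ->
    deriv Sg (add (sTr (arel a0 a1) t0 t1) G) D
| d_relR : forall Sg s (a0 a1 : action Sg s) t t0 t1 G D G' D',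
    deriv Sg G (add (sTr a0 t t0) D) -> deriv Sg G' (add (sTr a1 t t1) D') ->
    deriv Sg (cup G G') (add (sTr (arel a0 a1) t0 t1) (cup D D'))
| d_impL : forall Sg (phi psi : sentence Sg) G0 D0 G1 D1,
    deriv Sg G0 (add phi D0) -> deriv Sg (add psi G1) D1 ->
    deriv Sg (add (sImp phi psi) (cup G0 G1)) (cup D0 D1)
| d_impR : forall Sg (phi psi : sentence Sg) G D,
    deriv Sg (add phi G) (add psi D) -> deriv Sg G (add (sImp phi psi) D)
| d_orL : forall Sg (Phi : list (sentence Sg)) (GF DF : nat -> sset Sg),
    (forall i phi, nth_error Phi i = Some phi -> deriv Sg (add phi (GF i)) (DF i)) ->
    deriv Sg (add (sOr Phi) (bigcup Phi GF)) (bigcup Phi DF)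
| d_orR : forall Sg (Phi : list (sentence Sg)) phi G D,
    In phi Phi -> deriv Sg G (add phi D) -> deriv Sg G (add (sOr Phi) D)
| d_andL : forall Sg (Phi : list (sentence Sg)) phi G D,
    In phi Phi -> deriv Sg (add phi G) D -> deriv Sg (add (sAnd Phi) G) D
| d_andR : forall Sg (Phi : list (sentence Sg)) (GF DF : nat -> sset Sg),
    (forall i phi, nth_error Phi i = Some phi -> deriv Sg (GF i) (add phi (DF i))) ->
    deriv Sg (bigcup Phi GF) (add (sAnd Phi) (bigcup Phi DF))
| d_exL : forall Sg (X : block Sg) phi G D,
    deriv (ext Sg X) (add phi (up X G)) (up X D) -> deriv Sg (add (sEx X phi) G) D
| d_exR : forall Sg (X : block Sg) phi (th : subst Sg X) G D,
    deriv Sg G (add (inst th phi) D) -> deriv Sg G (add (sEx X phi) D)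
| d_allL : forall Sg (X : block Sg) phi (th : subst Sg X) G D,
    deriv Sg (add (inst th phi) G) D -> deriv Sg (add (sAll X phi) G) D
| d_allR : forall Sg (X : block Sg) phi G D,
    deriv (ext Sg X) (up X G) (add phi (up X D)) -> deriv Sg G (add (sAll X phi) D)
| d_starAx : forall Sg s (a : action Sg s) t0 t1 G D,
    deriv Sg (add (sTr (astar a) t0 t1) G) (add (sTr (astar a) t0 t1) D)
| d_starCut : forall Sg s (a : action Sg s) t0 t1 G0 D0 G1 D1,
    deriv Sg G0 (add (sTr (astar a) t0 t1) D0) -> deriv Sg (add (sTr (astar a) t0 t1) G1) D1 ->
    deriv Sg (cup G0 G1) (cup D0 D1)
| d_starR0 : forall Sg s (a : action Sg s) t0 t1 G D,
    deriv Sg G (add (sEq t0 t1) D) -> deriv Sg G (add (sTr (astar a) t0 t1) D)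
| d_starR1 : forall Sg s (a : action Sg s) t0 t t1 G D G' D',
    deriv Sg G (add (sTr (astar a) t0 t) D) -> deriv Sg G' (add (sTr a t t1) D') ->
    deriv Sg (cup G G') (add (sTr (astar a) t0 t1) (cup D D'))
| d_starR2 : forall Sg s (a : action Sg s) t0 t t1 G D G' D',
    deriv Sg G (add (sTr a t0 t) D) -> deriv Sg G' (add (sTr (astar a) t t1) D') ->
    deriv Sg (cup G G') (add (sTr (astar a) t0 t1) (cup D D'))
| d_starIndL : forall Sg s (a tt : action Sg s) (t t0 t1 : term Sg s) GL DL GM DM GR DR,
    deriv Sg GL (add (sTr tt t t0) DL) ->
    deriv (ext Sg (b3 s))
      (add (sTr (EA (b3 s) tt) (vz s) (vx s))
        (add (sTr (EA (b3 s) a) (vx s) (vy s)) (up (b3 s) GM)))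
      (add (sTr (EA (b3 s) tt) (vz s) (vy s)) (up (b3 s) DM)) ->
    deriv Sg (add (sTr tt t t1) GR) DR ->
    deriv Sg (add (sTr (astar a) t0 t1) (cup GL (cup GM GR))) (cup DL (cup DM DR))
| d_starIndR : forall Sg s (a tt : action Sg s) (t t0 t1 : term Sg s) GL DL GM DM GR DR,
    deriv Sg GL (add (sTr tt t1 t) DL) ->
    deriv (ext Sg (b3 s))
      (add (sTr (EA (b3 s) a) (vx s) (vy s))
        (add (sTr (EA (b3 s) tt) (vy s) (vz s)) (up (b3 s) GM)))
      (add (sTr (EA (b3 s) tt) (vx s) (vz s)) (up (b3 s) DM)) ->
    deriv Sg (add (sTr tt t0 t) GR) DR ->
    deriv Sg (add (sTr (astar a) t0 t1) (cup GL (cup GM GR))) (cup DL (cup DM DR)).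

Record sigmor (S1 S2 : sig) : Type := SigMor {
  ss : srt S1 -> srt S2;
  sf : forall w s, fsym S1 w s -> fsym S2 (map ss w) (ss s);
  sl : forall s, lab S1 s -> lab S2 (ss s) }.
Arguments ss {S1 S2} _ _.
Arguments sf {S1 S2} _ {w s} _.
Arguments sl {S1 S2} _ {s} _.

Definition injective_sigmor {S1 S2} (i : sigmor S1 S2) : Prop :=
  (forall s s', ss i s = ss i s' -> s = s') /\
  (forall w s (f f' : fsym S1 w s), sf i f = sf i f' -> f = f') /\
  (forall s (l l' : lab S1 s), sl i l = sl i l' -> l = l').

Definition mor_of {S1 S2} (i : sigmor S1 S2) : mor S1 S2 :=
  Mor S1 S2 (ss i) (fun w s f => inl (sf i f)) (fun s l => alab (sl i l)).

Definition finite_sig (Sg : sig) : Prop :=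
  (exists l : list (srt Sg), forall s, In s l) /\
  (exists l : list {w : list (srt Sg) & {s : srt Sg & fsym Sg w s}},
      forall w s f, In (existT _ w (existT _ s f)) l) /\
  (exists l : list {s : srt Sg & lab Sg s}, forall s x, In (existT _ s x) l).

(* The eigenvariable rules are sound because a witness can
   be added to the model as the value of the fresh variable, and the two induction rules because
   their middle premise says that the relation denoted by [t] is closed under [a], hence under [a^*].

   Compactness has two independent halves. A derivation uses only finitely many sentences of its
   side sets: by induction on derivations, carrying a finite lower bound through every rule.
   It also uses only finitely many symbols: for some finite list [K] of symbols, the derivation
   pulls back along every injective signature inclusion whose image contains [K]. The
   subsignature spanned by [K] and by the finitely many side sentences is the required one.

   Incompleteness: {true -succ*-> false} together with all [~ (true -succ^n-> false)] is
   unsatisfiable, but every finite subset holds in [nat] with [false] interpreted as a large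
   number; by compactness and soundness the sequent is not derivable. *)

From Stdlib Require Import List Relations Classical FunctionalExtensionality PropExtensionality.
From Stdlib Require Import ProofIrrelevance Eqdep Program.Equality IndefiniteDescription Lia.
(* [Defs] is imported last because [Program.Equality] also exports a constant named [block]. *)
From Pilot Require Import Defs.
Import ListNotations.

Scheme term_ind' := Induction for term Sort Prop
with terms_ind' := Induction for terms Sort Prop.
Combined Scheme term_terms_ind from term_ind', terms_ind'.

Definition sentence_nested_ind (P : forall Sg, sentence Sg -> Prop)
  (Heq : forall Sg s (t0 t1 : term Sg s), P Sg (sEq t0 t1))
  (Htr : forall Sg s (a : action Sg s) t0 t1, P Sg (sTr a t0 t1))
  (Himp : forall Sg p q, P Sg p -> P Sg q -> P Sg (sImp p q))
  (Hor : forall Sg l, Forall (P Sg) l -> P Sg (sOr l))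
  (Hand : forall Sg l, Forall (P Sg) l -> P Sg (sAnd l))
  (Hex : forall Sg X p, P (ext Sg X) p -> P Sg (sEx X p))
  (Hall : forall Sg X p, P (ext Sg X) p -> P Sg (sAll X p)) :
  forall Sg phi, P Sg phi :=
  fix F Sg phi {struct phi} : P Sg phi :=
  match phi as phi0 in sentence S0 return P S0 phi0 with
  | sEq t0 t1 => Heq _ _ t0 t1
  | sTr a t0 t1 => Htr _ _ a t0 t1
  | sImp p q => Himp _ p q (F _ p) (F _ q)
  | @sOr S0 l => Hor _ l ((fix G (l : list (sentence S0)) : Forall (P S0) l :=
       match l with [] => Forall_nil _ | x :: l' => Forall_cons _ (F _ x) (G l') end) l)
  | @sAnd S0 l => Hand _ l ((fix G (l : list (sentence S0)) : Forall (P S0) l :=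
       match l with [] => Forall_nil _ | x :: l' => Forall_cons _ (F _ x) (G l') end) l)
  | sEx X p => Hex _ X p (F _ p)
  | sAll X p => Hall _ X p (F _ p)
  end.

Definition Some_injective {A : Type} {x y : A} (e : Some x = Some y) : x = y :=
  f_equal (fun o => match o with Some z => z | None => x end) e.

Ltac dep_inv H :=
  let e := fresh "e" in
  pose proof (f_equal (@projT1 _ _) H) as e; simpl in e; subst; apply inj_pair2 in H.

(** * Reducts and the satisfaction condition *)

Fixpoint tuple_reindex {A B : Type} (C : B -> Type) (f : A -> B) (w : list A) :
  tuple (fun s => C (f s)) w -> tuple C (map f w) :=
  match w return tuple (fun s => C (f s)) w -> tuple C (map f w) with
  | [] => fun x => x
  | s :: w' => fun x => (fst x, tuple_reindex C f w' (snd x))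
  end.

Definition reduct {S1 S2} (m : mor S1 S2) (M : model S2) : model S1 :=
  Model S1 (fun s => car M (ms m s))
    (fun w s f args => match mf m f with
                       | inl g => mfun M g (tuple_reindex (car M) (ms m) w args)
                       | inr u => evt M u end)
    (fun s l => aden M (ml m l)).

Lemma evt_reduct (S1 S2 : sig) (m : mor S1 S2) (M : model S2) :
  (forall s (t : term S1 s), evt M (trt m t) = evt (reduct m M) t) /\
  (forall w (ts : terms S1 w),
     evts M (trts m ts) = tuple_reindex (car M) (ms m) w (evts (reduct m M) ts)).
Proof.
  apply term_terms_ind.
  - intros w s f ts IH. simpl. destruct (mf m f); simpl; [rewrite IH|]; reflexivity.
  - reflexivity.
  - intros s w t IH ts IH2. simpl. rewrite IH, IH2. reflexivity.
Qed.

Lemma aden_reduct (S1 S2 : sig) (m : mor S1 S2) (M : model S2) s (a : action S1 s) :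
  aden M (tra m a) = aden (reduct m M) a.
Proof. induction a; simpl; try rewrite IHa1, IHa2; try rewrite IHa; reflexivity. Qed.

Lemma evt_embt_expand (Sg : sig) (Z : block Sg) (M : model Sg) v r :
  (forall s (t : term Sg s), evt (expand M Z v r) (embt Z t) = evt M t) /\
  (forall w (ts : terms Sg w), evts (expand M Z v r) (embts Z ts) = evts M ts).
Proof.
  apply term_terms_ind.
  - intros w s f ts IH. simpl. rewrite IH. reflexivity.
  - reflexivity.
  - intros s w t IH ts IH2. simpl. rewrite IH, IH2. reflexivity.
Qed.

Lemma aden_emba_expand (Sg : sig) (Z : block Sg) (M : model Sg) v r s (a : action Sg s) :
  aden (expand M Z v r) (emba Z a) = aden M a.
Proof. induction a; simpl; try rewrite IHa1, IHa2; try rewrite IHa; reflexivity. Qed.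

Section PushValuation.
Context {A B : Type} (f : A -> B) (C : B -> Type).

Fixpoint push_val (l : list A) :
  (forall s, var l s -> C (f s)) -> forall s2, var (map f l) s2 -> C s2 :=
  match l return (forall s, var l s -> C (f s)) -> forall s2, var (map f l) s2 -> C s2 with
  | [] => fun _ s2 u => False_rect _ (match u with exist _ i e =>
           match i return nth_error (map f []) i = Some s2 -> False with
           | 0 => fun e => ltac:(discriminate e) | S _ => fun e => ltac:(discriminate e) end e end)
  | a :: l' => fun v s2 u => match u with exist _ i e =>
      match i return nth_error (map f (a :: l')) i = Some s2 -> C s2 with
      | 0 => fun e => eq_rect (f a) C (v a (exist _ 0 eq_refl)) s2 (Some_injective e)
      | S j => fun e =>
          push_val l' (fun s u' => v s (exist _ (S (proj1_sig u')) (proj2_sig u'))) s2 (exist _ j e)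
      end e end
  end.

Lemma push_val_nth l v s i (E : nth_error l i = Some s) (E' : nth_error (map f l) i = Some (f s)) :
  push_val l v (f s) (exist _ i E') = v s (exist _ i E).
Proof.
  revert v s i E E'. induction l as [|a l IH]; intros v s i E E'.
  - destruct i; discriminate E.
  - destruct i as [|j].
    + simpl in E. pose proof (Some_injective E) as H. subst s.
      simpl. rewrite (UIP_refl _ _ (Some_injective E')), (UIP_refl _ _ E). reflexivity.
    + exact (IH (fun s0 u' => v s0 (exist _ (S (proj1_sig u')) (proj2_sig u'))) s j E E').
Qed.

Lemma push_val_mapvar l v s (u : var l s) : push_val l v (f s) (mapvar f l s u) = v s u.
Proof. destruct u. apply push_val_nth. Qed.
End PushValuation.

Lemma reduct_lift_expand (S1 S2 : sig) (m : mor S1 S2) (M : model S2) (X : block S1) v r :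
  reduct (lift m X) (expand M (mapb (ms m) X) v r) =
  expand (reduct m M) X (fun s u => v (ms m s) (mapvar (ms m) (fst X) s u))
                        (fun s u => r (ms m s) (mapvar (ms m) (snd X) s u)).
Proof.
  unfold reduct, expand. simpl. f_equal.
  - apply functional_extensionality_dep; intro w.
    apply functional_extensionality_dep; intro s.
    apply functional_extensionality_dep; intros [g|u].
    + simpl. destruct (mf m g) as [h|u]; simpl; [reflexivity|].
      apply functional_extensionality; intro args.
      exact (proj1 (evt_embt_expand S2 (mapb (ms m) X) M v r) _ u).
    + destruct w; [|destruct u]. reflexivity.
  - apply functional_extensionality_dep; intro s.
    apply functional_extensionality_dep; intros [l0|u]; simpl; [|reflexivity].
    exact (aden_emba_expand S2 (mapb (ms m) X) M v r _ (ml m l0)).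
Qed.

Lemma reduct_lift_expand_push (S1 S2 : sig) (m : mor S1 S2) (M : model S2) (X : block S1) v r :
  reduct (lift m X)
    (expand M (mapb (ms m) X) (push_val (ms m) (car M) (fst X) v)
                              (push_val (ms m) (fun s => car M s -> car M s -> Prop) (snd X) r)) =
  expand (reduct m M) X v r.
Proof.
  rewrite reduct_lift_expand. f_equal;
    apply functional_extensionality_dep; intro s; apply functional_extensionality; intro u.
  - apply push_val_mapvar.
  - exact (push_val_mapvar _ (fun s => car M s -> car M s -> Prop) _ _ _ _).
Qed.

Lemma sat_trs (S1 : sig) (phi : sentence S1) (S2 : sig) (m : mor S1 S2) (M : model S2) :
  sat (trs phi S2 m) M <-> sat phi (reduct m M).
Proof.
  revert S1 phi S2 m M.
  apply (sentence_nested_ind (fun S1 phi => forall S2 (m : mor S1 S2) (M : model S2),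
    sat (trs phi S2 m) M <-> sat phi (reduct m M))).
  - intros. simpl. rewrite !(proj1 (evt_reduct _ _ m M)). tauto.
  - intros. simpl. rewrite !(proj1 (evt_reduct _ _ m M)), aden_reduct. tauto.
  - intros Sg p q IHp IHq S2 m M. simpl. rewrite IHp, IHq. tauto.
  - intros Sg l IH S2 m M. simpl. induction IH as [|x l Hx Hl IHl]; simpl; [tauto|].
    rewrite Hx, IHl. tauto.
  - intros Sg l IH S2 m M. simpl. induction IH as [|x l Hx Hl IHl]; simpl; [tauto|].
    rewrite Hx, IHl. tauto.
  - intros Sg X p IH S2 m M. simpl. split.
    + intros [v [r H]]. apply IH in H. rewrite reduct_lift_expand in H. eauto.
    + intros [v [r H]]. do 2 eexists. apply IH. rewrite reduct_lift_expand_push. exact H.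
  - intros Sg X p IH S2 m M. simpl. split.
    + intros H v r. specialize (H (push_val _ _ _ v) (push_val _ _ _ r)).
      apply IH in H. rewrite reduct_lift_expand_push in H. exact H.
    + intros H v r. apply IH. rewrite reduct_lift_expand. apply H.
Qed.

Lemma tuple_reindex_id (A : Type) (C : A -> Type) w (args : tuple C w) :
  existT (tuple C) (map (fun x => x) w) (tuple_reindex C (fun x => x) w args) =
  existT (tuple C) w args.
Proof.
  induction w as [|s w IH]; [reflexivity|]. destruct args as [y t]. simpl.
  exact (f_equal (fun p : sigT (tuple C) => existT (tuple C) (s :: projT1 p) (y, projT2 p)) (IH t)).
Qed.

Lemma mfun_eq_rect (Sg : sig) (M : model Sg) s w w' (e : w = w') (f : fsym Sg w s)
  (args' : tuple (car M) w') args :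
  existT (tuple (car M)) w' args' = existT (tuple (car M)) w args ->
  mfun M (eq_rect w (fun w0 => fsym Sg w0 s) f w' e) args' = mfun M f args.
Proof. intros H. destruct e. simpl. apply inj_pair2 in H. subst. reflexivity. Qed.

Lemma mfun_castw (Sg : sig) (M : model Sg) w s (f : fsym Sg w s) args :
  mfun M (castw f) (tuple_reindex (car M) (fun x => x) w args) = mfun M f args.
Proof. unfold castw, eq_rect_r. apply mfun_eq_rect, tuple_reindex_id. Qed.

Lemma reduct_incl_expand (Sg : sig) X (M : model Sg) v r : reduct (incl Sg X) (expand M X v r) = M.
Proof.
  destruct M as [c f l]. unfold reduct, expand. simpl. f_equal.
  apply functional_extensionality_dep; intro w.
  apply functional_extensionality_dep; intro s.
  apply functional_extensionality_dep; intro g.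
  apply functional_extensionality; intro args.
  exact (mfun_castw Sg (Model Sg c f l) w s g args).
Qed.

Lemma reduct_subst (Sg : sig) X (th : subst Sg X) (M : model Sg) :
  reduct (subst_mor th) M =
  expand M X (fun s v => evt M (sub_f th s v)) (fun s v => aden M (sub_l th s v)).
Proof.
  unfold reduct, expand. simpl. f_equal.
  - apply functional_extensionality_dep; intro w.
    apply functional_extensionality_dep; intro s.
    apply functional_extensionality_dep; intros [g|u].
    + apply functional_extensionality; intro args. apply mfun_castw.
    + destruct w; [|destruct u]. reflexivity.
  - apply functional_extensionality_dep; intro s.
    apply functional_extensionality_dep; intros [l|u]; reflexivity.
Qed.

Lemma sat_incl_expand (Sg : sig) X (phi : sentence Sg) (M : model Sg) v r :
  sat (trs phi _ (incl Sg X)) (expand M X v r) <-> sat phi M.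
Proof. rewrite sat_trs, reduct_incl_expand. tauto. Qed.

Lemma sat_inst (Sg : sig) X (th : subst Sg X) phi (M : model Sg) :
  sat (inst th phi) M <->
  sat phi (expand M X (fun s v => evt M (sub_f th s v)) (fun s v => aden M (sub_l th s v))).
Proof. unfold inst. rewrite sat_trs, reduct_subst. tauto. Qed.

Lemma evt_E_expand_gen (Sg : sig) X (M : model Sg) v r :
  (forall s (t : term Sg s), evt (expand M X v r) (trt (incl Sg X) t) = evt M t) /\
  (forall w (ts : terms Sg w),
     evts (expand M X v r) (trts (incl Sg X) ts) = tuple_reindex (car M) (fun x => x) w (evts M ts)).
Proof.
  apply term_terms_ind.
  - intros w s f ts IH. simpl. rewrite <- (mfun_castw Sg M w s f), <- IH. reflexivity.
  - reflexivity.
  - intros s w t IH ts IH2. simpl. f_equal; assumption.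
Qed.

Lemma evt_E_expand (Sg : sig) X (M : model Sg) v r s (t : term Sg s) :
  evt (expand M X v r) (E X t) = evt M t.
Proof. apply evt_E_expand_gen. Qed.

Lemma aden_EA_expand (Sg : sig) X (M : model Sg) v r s (a : action Sg s) :
  aden (expand M X v r) (EA X a) = aden M a.
Proof. unfold EA. induction a; simpl; try rewrite IHa1, IHa2; try rewrite IHa; reflexivity. Qed.

(** * Soundness *)

Definition sat_all {Sg} (M : model Sg) (G : sset Sg) : Prop := forall phi, G phi -> sat phi M.
Definition sat_some {Sg} (M : model Sg) (D : sset Sg) : Prop := exists psi, D psi /\ sat psi M.

Lemma sat_sTr (Sg : sig) s (a : action Sg s) t0 t1 (M : model Sg) :
  sat (sTr a t0 t1) M = aden M a (evt M t0) (evt M t1).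
Proof. reflexivity. Qed.

Lemma sat_all_add (Sg : sig) (G : sset Sg) P M : sat_all M (add P G) -> sat P M /\ sat_all M G.
Proof. unfold sat_all, add. auto. Qed.

Lemma sat_all_add_intro (Sg : sig) (G : sset Sg) P M : sat P M -> sat_all M G -> sat_all M (add P G).
Proof. intros HP HG phi [->|H]; auto. Qed.

Lemma sat_all_cup (Sg : sig) (G1 G2 : sset Sg) M :
  sat_all M (cup G1 G2) -> sat_all M G1 /\ sat_all M G2.
Proof. unfold sat_all, cup. auto. Qed.

Lemma sat_some_add (Sg : sig) (D : sset Sg) P M : sat P M -> sat_some M (add P D).
Proof. exists P. unfold add. auto. Qed.

Lemma sat_some_add_r (Sg : sig) (D : sset Sg) P M : sat_some M D -> sat_some M (add P D).
Proof. intros [psi [? ?]]. exists psi. unfold add. auto. Qed.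

Lemma sat_some_add_inv (Sg : sig) (D : sset Sg) P M :
  sat_some M (add P D) -> sat P M \/ sat_some M D.
Proof. intros [psi [[->|H] S]]; [left|right; exists psi]; auto. Qed.

Lemma sat_some_cup_l (Sg : sig) (D1 D2 : sset Sg) M : sat_some M D1 -> sat_some M (cup D1 D2).
Proof. intros [psi [? ?]]. exists psi. unfold cup. auto. Qed.

Lemma sat_some_cup_r (Sg : sig) (D1 D2 : sset Sg) M : sat_some M D2 -> sat_some M (cup D1 D2).
Proof. intros [psi [? ?]]. exists psi. unfold cup. auto. Qed.

Lemma sat_all_up (Sg : sig) X (G : sset Sg) M v r :
  sat_all M G -> sat_all (expand M X v r) (up X G).
Proof. intros H phi [p [Hp ->]]. apply sat_incl_expand. auto. Qed.

Lemma sat_some_up (Sg : sig) X (D : sset Sg) M v r :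
  sat_some (expand M X v r) (up X D) -> sat_some M D.
Proof. intros [psi [[p [Hp ->]] S]]. apply sat_incl_expand in S. exists p. auto. Qed.

Lemma sat_all_bigcup (Sg : sig) (Phi : list (sentence Sg)) GF M i phi :
  sat_all M (bigcup Phi GF) -> nth_error Phi i = Some phi -> sat_all M (GF i).
Proof. intros H Ei psi Hp. apply H. exists i, phi. auto. Qed.

Lemma sat_some_bigcup (Sg : sig) (Phi : list (sentence Sg)) DF M i phi :
  nth_error Phi i = Some phi -> sat_some M (DF i) -> sat_some M (bigcup Phi DF).
Proof. intros Ei [psi [H S]]. exists psi. split; auto. exists i, phi. auto. Qed.

Lemma valid_r_elim (Sg : sig) (G D : sset Sg) P M :
  valid Sg G (add P D) -> sat_all M G -> ~ sat_some M D -> sat P M.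
Proof. intros H HM HN. destruct (sat_some_add_inv _ _ _ _ (H M HM)); tauto. Qed.

Lemma valid_l_elim (Sg : sig) (G D : sset Sg) P M :
  valid Sg (add P G) D -> sat_all M G -> sat P M -> sat_some M D.
Proof. intros H HM HP. apply H, sat_all_add_intro; assumption. Qed.

Lemma sat_or_nth (Sg : sig) (Phi : list (sentence Sg)) M :
  sat (sOr Phi) M -> exists i phi, nth_error Phi i = Some phi /\ sat phi M.
Proof.
  simpl. induction Phi as [|p Phi IH]; simpl; [tauto|].
  intros [H|H]; [exists 0, p; auto|]. destruct (IH H) as [i [phi [E Hs]]]. exists (S i), phi. auto.
Qed.

Lemma sat_or_intro (Sg : sig) (Phi : list (sentence Sg)) phi M :
  In phi Phi -> sat phi M -> sat (sOr Phi) M.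
Proof.
  simpl. induction Phi as [|p Phi IH]; simpl; [tauto|].
  intros [->|H] Hs; [left|right; apply IH]; auto.
Qed.

Lemma sat_and_elim (Sg : sig) (Phi : list (sentence Sg)) phi M :
  In phi Phi -> sat (sAnd Phi) M -> sat phi M.
Proof.
  simpl. induction Phi as [|p Phi IH]; simpl; [tauto|].
  intros [->|H] [Hs1 Hs2]; auto.
Qed.

Lemma sat_and_nth (Sg : sig) (Phi : list (sentence Sg)) M :
  (forall i phi, nth_error Phi i = Some phi -> sat phi M) -> sat (sAnd Phi) M.
Proof.
  simpl. induction Phi as [|p Phi IH]; simpl; [tauto|].
  intros H. split; [apply (H 0); reflexivity|]. apply IH. intros i phi E. apply (H (S i)). auto.
Qed.

Lemma evts_argpair_eq (Sg : sig) (M : model Sg) w (ts ts' : terms Sg w) :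
  (forall s' (u u' : term Sg s'), argpair Sg w ts ts' s' u u' -> evt M u = evt M u') ->
  evts M ts = evts M ts'.
Proof.
  revert ts'. induction ts as [|s w t ts IH]; intros ts' H; dependent destruction ts'; simpl.
  - reflexivity.
  - f_equal; [apply H; constructor|apply IH; intros; apply H; constructor; auto].
Qed.

Ltac case_sat_some HS D :=
  match goal with M : model _ |- _ => destruct (classic (sat_some M D)) as [HS|HS] end.

Lemma bderiv_sound (Sg : sig) G D : bderiv Sg G D -> valid Sg G D.
Proof.
  induction 1; intros M HM;
    [apply sat_all_add in HM as [HP _]; apply sat_some_add; auto|
     apply sat_some_add; reflexivity|..];
    case_sat_some HS D; try (apply sat_some_add_r; assumption); apply sat_some_add; simpl.
  - symmetry. exact (valid_r_elim _ _ _ _ _ IHbderiv HM HS).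
  - pose proof (valid_r_elim _ _ _ _ _ IHbderiv1 HM HS).
    pose proof (valid_r_elim _ _ _ _ _ IHbderiv2 HM HS).
    simpl in *. congruence.
  - f_equal. apply evts_argpair_eq. intros. exact (valid_r_elim _ _ _ _ _ (H0 _ _ _ H1) HM HS).
  - pose proof (valid_r_elim _ _ _ _ _ IHbderiv1 HM HS).
    pose proof (valid_r_elim _ _ _ _ _ IHbderiv2 HM HS).
    pose proof (valid_r_elim _ _ _ _ _ IHbderiv3 HM HS). simpl in *. congruence.
Qed.

Lemma nth_error_singleton_eq (A : Type) (s s' : A) i : nth_error [s] i = Some s' -> s = s'.
Proof. destruct i as [|[|i]]; simpl; intros e; try discriminate; injection e; auto. Qed.

Lemma nth_error_triple_eq (A : Type) (s s' : A) i : nth_error [s; s; s] i = Some s' -> s = s'.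
Proof. destruct i as [|[|[|[|i]]]]; simpl; intros e; try discriminate; injection e; auto. Qed.

Definition no_labels {Sg} (M : model Sg) (X : block Sg) :
  forall s, var (snd X) s -> car M s -> car M s -> Prop := fun _ _ _ _ => True.

Definition expand_b1 {Sg} (M : model Sg) s (x : car M s) : model (ext Sg (b1 s)) :=
  expand M (b1 s)
    (fun s' u => eq_rect s (car M) x s' (nth_error_singleton_eq _ s s' _ (proj2_sig u)))
    (no_labels M (b1 s)).

Definition expand_b3 {Sg} (M : model Sg) s (x y z : car M s) : model (ext Sg (b3 s)) :=
  expand M (b3 s)
    (fun s' u => eq_rect s (car M) (match proj1_sig u with 0 => x | 1 => y | _ => z end) s'
                   (nth_error_triple_eq _ s s' _ (proj2_sig u)))
    (no_labels M (b3 s)).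

Lemma evt_vx1 (Sg : sig) (M : model Sg) s x : evt (expand_b1 M s x) (vx1 s) = x.
Proof. simpl. rewrite (UIP_refl _ _ (nth_error_singleton_eq _ _ _ _ _)). reflexivity. Qed.

Lemma evt_vx (Sg : sig) (M : model Sg) s x y z : evt (expand_b3 M s x y z) (vx s) = x.
Proof. simpl. rewrite (UIP_refl _ _ (nth_error_triple_eq _ _ _ _ _)). reflexivity. Qed.

Lemma evt_vy (Sg : sig) (M : model Sg) s x y z : evt (expand_b3 M s x y z) (vy s) = y.
Proof. simpl. rewrite (UIP_refl _ _ (nth_error_triple_eq _ _ _ _ _)). reflexivity. Qed.

Lemma evt_vz (Sg : sig) (M : model Sg) s x y z : evt (expand_b3 M s x y z) (vz s) = z.
Proof. simpl. rewrite (UIP_refl _ _ (nth_error_triple_eq _ _ _ _ _)). reflexivity. Qed.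

Lemma valid_up2_elim (Sg : sig) X A B (G : sset Sg) D' M v r :
  valid (ext Sg X) (add A (add B (up X G))) D' -> sat_all M G ->
  sat A (expand M X v r) -> sat B (expand M X v r) -> sat_some (expand M X v r) D'.
Proof.
  intros H HM HA HB. apply H, sat_all_add_intro, sat_all_add_intro; auto. apply sat_all_up. auto.
Qed.

Lemma valid_b3_elim (Sg : sig) s (A B C : sentence (ext Sg (b3 s))) GM DM M x y z :
  valid _ (add A (add B (up (b3 s) GM))) (add C (up (b3 s) DM)) -> sat_all M GM -> ~ sat_some M DM ->
  sat A (expand_b3 M s x y z) -> sat B (expand_b3 M s x y z) -> sat C (expand_b3 M s x y z).
Proof.
  intros H HM HD HA HB.
  destruct (sat_some_add_inv _ _ _ _ (valid_up2_elim _ _ _ _ _ _ _ _ _ H HM HA HB)) as [HC|HC]; auto.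
  apply sat_some_up in HC. contradiction.
Qed.

Lemma rt_closed_right {A} (R T : relation A) :
  (forall z x y, T z x -> R x y -> T z y) ->
  forall x y, clos_refl_trans A R x y -> forall z, T z x -> T z y.
Proof. intros Hstep x y H. induction H; eauto. Qed.

Lemma rt_closed_left {A} (R T : relation A) :
  (forall x y z, R x y -> T y z -> T x z) ->
  forall x y, clos_refl_trans A R x y -> forall z, T y z -> T x z.
Proof. intros Hstep x y H. induction H; eauto. Qed.

Lemma valid_witness_b1_L (Sg : sig) s (P : sentence Sg) (A0 A1 : sentence (ext Sg (b1 s))) G D :
  (forall M, sat P M -> exists y, sat A0 (expand_b1 M s y) /\ sat A1 (expand_b1 M s y)) ->
  valid _ (add A0 (add A1 (up (b1 s) G))) (up (b1 s) D) ->
  valid Sg (add P G) D.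
Proof.
  intros Hwit H M HM. apply sat_all_add in HM as [HP HM].
  destruct (Hwit M HP) as [y [H0 H1]].
  exact (sat_some_up _ _ _ _ _ _ (valid_up2_elim _ _ _ _ _ _ _ _ _ H HM H0 H1)).
Qed.

Lemma valid_starIndL (Sg : sig) s (a tt : action Sg s) (t t0 t1 : term Sg s) GL DL GM DM GR DR :
  valid Sg GL (add (sTr tt t t0) DL) ->
  valid (ext Sg (b3 s))
    (add (sTr (EA (b3 s) tt) (vz s) (vx s)) (add (sTr (EA (b3 s) a) (vx s) (vy s)) (up (b3 s) GM)))
    (add (sTr (EA (b3 s) tt) (vz s) (vy s)) (up (b3 s) DM)) ->
  valid Sg (add (sTr tt t t1) GR) DR ->
  valid Sg (add (sTr (astar a) t0 t1) (cup GL (cup GM GR))) (cup DL (cup DM DR)).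
Proof.
  intros HL HM HR M Hsat.
  apply sat_all_add in Hsat as [Hstar Hsat].
  apply sat_all_cup in Hsat as [HGL Hsat]. apply sat_all_cup in Hsat as [HGM HGR].
  case_sat_some HDL DL; [apply sat_some_cup_l; assumption|].
  case_sat_some HDM DM; [apply sat_some_cup_r, sat_some_cup_l; assumption|].
  apply sat_some_cup_r, sat_some_cup_r, (valid_l_elim _ _ _ _ _ HR HGR). rewrite sat_sTr.
  refine (rt_closed_right _ _ _ _ _ Hstar _ (valid_r_elim _ _ _ _ _ HL HGL HDL)).
  intros z x y Hzx Hxy. pose proof (valid_b3_elim _ _ _ _ _ _ _ M x y z HM HGM HDM) as Hstep.
  rewrite !sat_sTr, evt_vx, evt_vy, evt_vz in Hstep. unfold expand_b3 in Hstep.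
  rewrite !aden_EA_expand in Hstep. auto.
Qed.

Lemma valid_starIndR (Sg : sig) s (a tt : action Sg s) (t t0 t1 : term Sg s) GL DL GM DM GR DR :
  valid Sg GL (add (sTr tt t1 t) DL) ->
  valid (ext Sg (b3 s))
    (add (sTr (EA (b3 s) a) (vx s) (vy s)) (add (sTr (EA (b3 s) tt) (vy s) (vz s)) (up (b3 s) GM)))
    (add (sTr (EA (b3 s) tt) (vx s) (vz s)) (up (b3 s) DM)) ->
  valid Sg (add (sTr tt t0 t) GR) DR ->
  valid Sg (add (sTr (astar a) t0 t1) (cup GL (cup GM GR))) (cup DL (cup DM DR)).
Proof.
  intros HL HM HR M Hsat.
  apply sat_all_add in Hsat as [Hstar Hsat].
  apply sat_all_cup in Hsat as [HGL Hsat]. apply sat_all_cup in Hsat as [HGM HGR].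
  case_sat_some HDL DL; [apply sat_some_cup_l; assumption|].
  case_sat_some HDM DM; [apply sat_some_cup_r, sat_some_cup_l; assumption|].
  apply sat_some_cup_r, sat_some_cup_r, (valid_l_elim _ _ _ _ _ HR HGR). rewrite sat_sTr.
  refine (rt_closed_left _ _ _ _ _ Hstar _ (valid_r_elim _ _ _ _ _ HL HGL HDL)).
  intros x y z Hxy Hyz. pose proof (valid_b3_elim _ _ _ _ _ _ _ M x y z HM HGM HDM) as Hstep.
  rewrite !sat_sTr, evt_vx, evt_vy, evt_vz in Hstep. unfold expand_b3 in Hstep.
  rewrite !aden_EA_expand in Hstep. auto.
Qed.

Lemma valid_r1 (Sg : sig) (G D : sset Sg) P Q :
  valid Sg G (add P D) -> (forall M, sat P M -> sat Q M) -> valid Sg G (add Q D).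
Proof.
  intros H HPQ M HM. destruct (sat_some_add_inv _ _ _ _ (H M HM)).
  - apply sat_some_add. auto.
  - apply sat_some_add_r. assumption.
Qed.

Lemma valid_l1 (Sg : sig) (G D : sset Sg) P Q :
  valid Sg (add P G) D -> (forall M, sat Q M -> sat P M) -> valid Sg (add Q G) D.
Proof. intros H HQP M HM. apply sat_all_add in HM as [HQ HM].
  exact (valid_l_elim _ _ _ _ _ H HM (HQP M HQ)).
Qed.

Lemma valid_r2 (Sg : sig) (G G' D D' : sset Sg) P Q R :
  valid Sg G (add P D) -> valid Sg G' (add Q D') -> (forall M, sat P M -> sat Q M -> sat R M) ->
  valid Sg (cup G G') (add R (cup D D')).
Proof.
  intros H H' HR M HM. apply sat_all_cup in HM as [HM HM'].
  case_sat_some HS D; [apply sat_some_add_r, sat_some_cup_l; assumption|].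
  case_sat_some HS' D'; [apply sat_some_add_r, sat_some_cup_r; assumption|].
  apply sat_some_add, HR; [exact (valid_r_elim _ _ _ _ _ H HM HS)|exact (valid_r_elim _ _ _ _ _ H' HM' HS')].
Qed.

Lemma valid_r_imp (Sg : sig) (G D : sset Sg) P Q R :
  valid Sg (add P G) (add Q D) -> (forall M, (sat P M -> sat Q M) -> sat R M) -> valid Sg G (add R D).
Proof.
  intros H HR M HM. case_sat_some HS D; [apply sat_some_add_r; assumption|].
  apply sat_some_add, HR. intros HP.
  destruct (sat_some_add_inv _ _ _ _ (H M (sat_all_add_intro _ _ _ _ HP HM))); tauto.
Qed.

Lemma valid_l2 (Sg : sig) (G G' D D' : sset Sg) P Q R :
  valid Sg G (add P D) -> valid Sg (add Q G') D' -> (forall M, sat R M -> sat P M -> sat Q M) ->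
  valid Sg (add R (cup G G')) (cup D D').
Proof.
  intros H H' HR M HM. apply sat_all_add in HM as [HRM HM]. apply sat_all_cup in HM as [HM HM'].
  case_sat_some HS D; [apply sat_some_cup_l; assumption|]. apply sat_some_cup_r.
  exact (valid_l_elim _ _ _ _ _ H' HM' (HR M HRM (valid_r_elim _ _ _ _ _ H HM HS))).
Qed.

Lemma valid_cut (Sg : sig) (G G' D D' : sset Sg) P :
  valid Sg G (add P D) -> valid Sg (add P G') D' -> valid Sg (cup G G') (cup D D').
Proof.
  intros H H' M HM. apply sat_all_cup in HM as [HM HM'].
  case_sat_some HS D; [apply sat_some_cup_l; assumption|]. apply sat_some_cup_r.
  exact (valid_l_elim _ _ _ _ _ H' HM' (valid_r_elim _ _ _ _ _ H HM HS)).
Qed.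

Theorem deriv_sound (Sg : sig) G D : deriv Sg G D -> valid Sg G D.
Proof.
  induction 1.
  - intros M HM. apply sat_all_cup in HM as [HM _].
    apply sat_some_cup_r, (bderiv_sound _ _ _ H1 M HM).
  - intros M HM. apply sat_all_add in HM as [[] _].
  - intros M HM. apply sat_all_add in HM as [[HP|HP] HM]; apply sat_all_cup in HM as [HM0 HM1].
    + apply sat_some_cup_l, (valid_l_elim _ _ _ _ _ IHderiv1 HM0 HP).
    + apply sat_some_cup_r, (valid_l_elim _ _ _ _ _ IHderiv2 HM1 HP).
  - apply (valid_r1 _ _ _ _ _ IHderiv). intros M HP. left. exact HP.
  - apply (valid_r1 _ _ _ _ _ IHderiv). intros M HP. right. exact HP.
  - apply (valid_l2 _ _ _ _ _ _ _ _ IHderiv1 IHderiv2). intros M [HP|HP] HP'; tauto.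
  - apply (valid_r_imp _ _ _ _ _ _ IHderiv). intros M Himp. simpl.
    destruct (classic (aden M a0 (evt M t0) (evt M t1))); tauto.
  - apply (valid_l1 _ _ _ _ _ IHderiv). auto.
  - apply (valid_r1 _ _ _ _ _ IHderiv). auto.
  - refine (valid_witness_b1_L _ _ _ _ _ _ _ _ IHderiv).
    intros M [y [H0 H1]]. exists y. rewrite !sat_sTr, !evt_vx1. unfold expand_b1.
    rewrite !aden_EA_expand, !evt_E_expand. auto.
  - apply (valid_r2 _ _ _ _ _ _ _ _ IHderiv1 IHderiv2). intros M HP HQ. exists (evt M t). auto.
  - refine (valid_witness_b1_L _ _ _ _ _ _ _ _ IHderiv).
    intros M [y [H0 H1]]. exists y. rewrite !sat_sTr, !evt_vx1. unfold expand_b1.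
    rewrite !aden_EA_expand, !evt_E_expand. auto.
  - apply (valid_r2 _ _ _ _ _ _ _ _ IHderiv1 IHderiv2). intros M HP HQ. exists (evt M t). auto.
  - apply (valid_l2 _ _ _ _ _ _ _ _ IHderiv1 IHderiv2). auto.
  - apply (valid_r_imp _ _ _ _ _ _ IHderiv). auto.
  - intros M HM. apply sat_all_add in HM as [HP HM]. destruct (sat_or_nth _ _ _ HP) as [i [phi [Ei Sp]]].
    apply (sat_some_bigcup _ _ _ _ i phi Ei).
    exact (valid_l_elim _ _ _ _ _ (H0 i phi Ei) (sat_all_bigcup _ _ _ _ _ _ HM Ei) Sp).
  - apply (valid_r1 _ _ _ _ _ IHderiv). intros M. apply sat_or_intro. assumption.
  - apply (valid_l1 _ _ _ _ _ IHderiv). intros M. apply sat_and_elim. assumption.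
  - intros M HM. case_sat_some HS (bigcup Phi DF); [apply sat_some_add_r; assumption|].
    apply sat_some_add, sat_and_nth. intros i phi Ei.
    apply (valid_r_elim _ _ _ _ _ (H0 i phi Ei) (sat_all_bigcup _ _ _ _ _ _ HM Ei)).
    intros HS'. exact (HS (sat_some_bigcup _ _ _ _ i phi Ei HS')).
  - intros M HM. apply sat_all_add in HM as [[v [r HP]] HM]. apply (sat_some_up _ X D M v r).
    exact (IHderiv _ (sat_all_add_intro _ _ _ _ HP (sat_all_up _ _ _ _ _ _ HM))).
  - apply (valid_r1 _ _ _ _ _ IHderiv). intros M Hi. apply sat_inst in Hi. simpl. eauto.
  - apply (valid_l1 _ _ _ _ _ IHderiv). intros M HP. apply sat_inst, HP.
  - intros M HM. case_sat_some HS D; [apply sat_some_add_r; assumption|]. apply sat_some_add.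
    intros v r. destruct (sat_some_add_inv _ _ _ _ (IHderiv _ (sat_all_up _ _ _ _ v r HM))) as [H'|H'];
      [exact H'|contradiction (sat_some_up _ _ _ _ _ _ H')].
  - intros M HM. apply sat_all_add in HM as [HP _]. apply sat_some_add. exact HP.
  - exact (valid_cut _ _ _ _ _ _ IHderiv1 IHderiv2).
  - apply (valid_r1 _ _ _ _ _ IHderiv). intros M HE. rewrite sat_sTr, HE. apply rt_refl.
  - apply (valid_r2 _ _ _ _ _ _ _ _ IHderiv1 IHderiv2). intros M HP HQ.
    eapply rt_trans; [exact HP|apply rt_step; exact HQ].
  - apply (valid_r2 _ _ _ _ _ _ _ _ IHderiv1 IHderiv2). intros M HP HQ.
    eapply rt_trans; [apply rt_step; exact HP|exact HQ].
  - exact (valid_starIndL _ _ _ _ _ _ _ _ _ _ _ _ _ IHderiv1 IHderiv2 IHderiv3).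
  - exact (valid_starIndR _ _ _ _ _ _ _ _ _ _ _ _ _ IHderiv1 IHderiv2 IHderiv3).
Qed.

(** * Symbols and translation along signature inclusions *)

Inductive symbol (Sg : sig) : Type :=
| ySort (s : srt Sg)
| yFun (w : list (srt Sg)) (s : srt Sg) (f : fsym Sg w s)
| yLab (s : srt Sg) (l : lab Sg s).
Arguments ySort {Sg} s.
Arguments yFun {Sg w s} f.
Arguments yLab {Sg s} l.

Fixpoint syms_term {Sg s} (t : term Sg s) : list (symbol Sg) :=
  match t with app f ts => yFun f :: syms_terms ts end
with syms_terms {Sg w} (ts : terms Sg w) : list (symbol Sg) :=
  match ts with tnil => [] | tcons t ts => syms_term t ++ syms_terms ts end.

Fixpoint syms_action {Sg s} (a : action Sg s) : list (symbol Sg) :=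
  match a with
  | alab l => [yLab l]
  | azero s => [ySort s]
  | aone s => [ySort s]
  | aunion a b => syms_action a ++ syms_action b
  | aimp a b => syms_action a ++ syms_action b
  | aseq a b => syms_action a ++ syms_action b
  | arel a b => syms_action a ++ syms_action b
  | astar a => syms_action a
  end.

Definition base_symbol {Sg X} (y : symbol (ext Sg X)) : list (symbol Sg) :=
  match y with
  | ySort s => [@ySort Sg s]
  | @yFun _ w s f => match f with inl g => [@yFun Sg w s g] | inr _ => [] end
  | @yLab _ s l => match l with inl l0 => [@yLab Sg s l0] | inr _ => [] end
  end.
Definition base_syms {Sg X} (L : list (symbol (ext Sg X))) : list (symbol Sg) := flat_map base_symbol L.

Fixpoint syms {Sg} (phi : sentence Sg) {struct phi} : list (symbol Sg) :=
  match phi in sentence S0 return list (symbol S0) with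
  | sEq t0 t1 => syms_term t0 ++ syms_term t1
  | sTr a t0 t1 => syms_action a ++ syms_term t0 ++ syms_term t1
  | sImp p q => syms p ++ syms q
  | @sOr S0 l => (fix go (l : list (sentence S0)) := match l with [] => [] | p :: l => syms p ++ go l end) l
  | @sAnd S0 l => (fix go (l : list (sentence S0)) := match l with [] => [] | p :: l => syms p ++ go l end) l
  | sEx X p => map ySort (fst X ++ snd X) ++ base_syms (syms p)
  | sAll X p => map ySort (fst X ++ snd X) ++ base_syms (syms p)
  end.

Definition in_image {Sf Sg} (i : sigmor Sf Sg) (y : symbol Sg) : Prop :=
  match y with
  | ySort s => exists s', ss i s' = s
  | @yFun _ w s f => exists w' s' (f' : fsym Sf w' s'),
      existT (fun w => {s & fsym Sg w s}) (map (ss i) w') (existT _ (ss i s') (sf i f')) =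
      existT _ w (existT _ s f)
  | @yLab _ s l => exists s' (l' : lab Sf s'), existT (lab Sg) (ss i s') (sl i l') = existT _ s l
  end.
Definition covers {Sf Sg} (i : sigmor Sf Sg) (L : list (symbol Sg)) : Prop := forall y, In y L -> in_image i y.

Lemma covers_app : forall Sf Sg (i : sigmor Sf Sg) L1 L2, covers i (L1 ++ L2) <-> covers i L1 /\ covers i L2.
Proof.
  unfold covers. intros. split.
  - intros H. split; intros; apply H; apply in_or_app; auto.
  - intros [H1 H2] y Hy. apply in_app_or in Hy as [?|?]; auto.
Qed.
Lemma covers_cons : forall Sf Sg (i : sigmor Sf Sg) y L, covers i (y :: L) <-> in_image i y /\ covers i L.
Proof.
  unfold covers. intros. split.
  - intros H. split; [apply H; left; auto|]. intros; apply H; right; auto.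
  - intros [H1 H2] y' [E|Hy]; [subst|]; auto.
Qed.

Lemma map_injective A B (f : A -> B) : (forall x y, f x = f y -> x = y) ->
  forall l1 l2, map f l1 = map f l2 -> l1 = l2.
Proof.
  intros Hf l1. induction l1 as [|a l1 IH]; intros [|b l2] H; simpl in H; try discriminate; auto.
  injection H as H1 H2. f_equal; auto.
Qed.

Section Injectivity.
Context {Sf Sg : sig} (i : sigmor Sf Sg) (Hi : injective_sigmor i).

Definition term_head {S s} (t : term S s) : {w & (fsym S w s * terms S w)%type} :=
  match t with app f ts => existT _ _ (f, ts) end.

Lemma ss_injective : forall s s', ss i s = ss i s' -> s = s'.
Proof. apply (proj1 Hi). Qed.
Lemma map_ss_injective : forall w w', map (ss i) w = map (ss i) w' -> w = w'.
Proof. apply map_injective. apply ss_injective. Qed.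

Lemma trt_injective_dep :
  (forall s (t : term Sf s) s' (t' : term Sf s'),
    existT (term Sg) (ss i s) (trt (mor_of i) t) = existT _ (ss i s') (trt (mor_of i) t') ->
    existT (term Sf) s t = existT _ s' t') /\
  (forall w (ts ts' : terms Sf w), trts (mor_of i) ts = trts (mor_of i) ts' -> ts = ts').
Proof.
  apply term_terms_ind.
  - intros w s f ts IH s' [w' s'' f' ts'] H. simpl in H.
    pose proof (f_equal (@projT1 _ _) H) as e. simpl in e. apply ss_injective in e. subst s''.
    apply inj_pair2 in H.
    pose proof (f_equal term_head H) as H2. simpl in H2.
    pose proof (f_equal (@projT1 _ _) H2) as e. simpl in e. apply map_ss_injective in e. subst w'.
    apply inj_pair2 in H2. injection H2 as H3 H4.
    apply (proj1 (proj2 Hi)) in H3. subst f'. apply IH in H4. subst ts'. reflexivity.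
  - intros ts' _. dependent destruction ts'. reflexivity.
  - intros s w t IH ts IH2 ts' H. dependent destruction ts'. simpl in H. injection H as H1 H2.
    apply inj_pair2 in H1. apply inj_pair2 in H2.
    assert (E1 := IH _ t0 (f_equal (existT _ _) H1)). apply inj_pair2 in E1. subst.
    apply IH2 in H2. subst. reflexivity.
Qed.

Lemma trt_injective s (t t' : term Sf s) : trt (mor_of i) t = trt (mor_of i) t' -> t = t'.
Proof.
  intros. assert (E1 := proj1 trt_injective_dep _ t _ t' (f_equal (existT _ _) H)).
  apply inj_pair2 in E1. auto.
Qed.

Ltac dep_inv_ss H :=
  let e := fresh "e" in
  pose proof (f_equal (@projT1 _ _) H) as e; simpl in e; apply ss_injective in e; subst;
  apply inj_pair2 in H.

Ltac use_dep_ih IH H :=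
  let R := fresh "R" in
  apply inj_pair2 in H; pose proof (IH _ _ (f_equal (existT _ _) H)) as R; apply inj_pair2 in R; subst.

Lemma tra_injective_dep s (a : action Sf s) s' (a' : action Sf s') :
  existT (action Sg) (ss i s) (tra (mor_of i) a) = existT _ (ss i s') (tra (mor_of i) a') ->
  existT (action Sf) s a = existT _ s' a'.
Proof.
  revert s' a'. induction a; intros s' a' H; destruct a'; simpl in H; dep_inv_ss H;
    try discriminate; try reflexivity.
  1: injection H as H; apply inj_pair2, (proj2 (proj2 Hi)) in H; subst; reflexivity.
  1-4: injection H as H1 H2; use_dep_ih IHa1 H1; use_dep_ih IHa2 H2; reflexivity.
  injection H as H1; use_dep_ih IHa H1; reflexivity.
Qed.

Lemma tra_injective s (a a' : action Sf s) : tra (mor_of i) a = tra (mor_of i) a' -> a = a'.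
Proof.
  intros. assert (E1 := tra_injective_dep _ a _ a' (f_equal (existT _ _) H)). apply inj_pair2 in E1.
  auto.
Qed.

Lemma trt_preimage_dep :
  (forall s (t : term Sg s), covers i (syms_term t) ->
     exists s' (t' : term Sf s'), existT (term Sg) (ss i s') (trt (mor_of i) t') = existT _ s t) /\
  (forall w (ts : terms Sg w), covers i (syms_terms ts) ->
     exists w' (ts' : terms Sf w'), existT (terms Sg) (map (ss i) w') (trts (mor_of i) ts') = existT _ w ts).
Proof.
  apply term_terms_ind.
  - intros w s f ts IH HC. simpl in HC. apply covers_cons in HC as [[w' [s' [f' Hf]]] HC].
    pose proof (f_equal (@projT1 _ _) Hf) as e; simpl in e; subst w. apply inj_pair2 in Hf.
    pose proof (f_equal (@projT1 _ _) Hf) as e; simpl in e; subst s. apply inj_pair2 in Hf. subst f.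
    destruct (IH HC) as [w'' [ts' Hts]].
    pose proof (f_equal (@projT1 _ _) Hts) as e; simpl in e. apply map_ss_injective in e. subst w''.
    apply inj_pair2 in Hts. subst ts. exists s', (app f' ts'). reflexivity.
  - intros _. exists [], tnil. reflexivity.
  - intros s w t IH ts IH2 HC. simpl in HC. apply covers_app in HC as [H1 H2].
    destruct (IH H1) as [s' [t' Ht]]. destruct (IH2 H2) as [w' [ts' Hts]].
    dep_inv Ht. dep_inv Hts. subst. exists (s' :: w'), (tcons t' ts'). reflexivity.
Qed.

Lemma tra_preimage_dep s (a : action Sg s) :
  covers i (syms_action a) ->
  exists s' (a' : action Sf s'), existT (action Sg) (ss i s') (tra (mor_of i) a') = existT _ s a.
Proof.
  induction a; simpl; intros HC; try (apply covers_app in HC as [H1 H2];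
    destruct (IHa1 H1) as [s1 [b1 E1]], (IHa2 H2) as [s2 [b2 E2]]; dep_inv E1; dep_inv_ss E2; subst).
  - apply covers_cons in HC as [[s' [l' Hl]] _]. dep_inv Hl. subst. exists s', (alab l'). reflexivity.
  - apply covers_cons in HC as [[s' <-] _]. exists s', (azero s'). reflexivity.
  - apply covers_cons in HC as [[s' <-] _]. exists s', (aone s'). reflexivity.
  - exists s1, (aunion b1 b2). reflexivity.
  - exists s1, (aimp b1 b2). reflexivity.
  - exists s1, (aseq b1 b2). reflexivity.
  - exists s1, (arel b1 b2). reflexivity.
  - destruct (IHa HC) as [s1 [b1 E1]]. dep_inv E1. subst. exists s1, (astar b1). reflexivity.
Qed.

Lemma trt_preimage s (t : term Sg (ss i s)) : covers i (syms_term t) -> exists t', trt (mor_of i) t' = t.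
Proof.
  intros. destruct (proj1 trt_preimage_dep _ t H) as [s' [t' E1]].
  pose proof (f_equal (@projT1 _ _) E1) as e; simpl in e. apply ss_injective in e. subst.
  apply inj_pair2 in E1. eauto.
Qed.
Lemma tra_preimage s (a : action Sg (ss i s)) : covers i (syms_action a) -> exists a', tra (mor_of i) a' = a.
Proof.
  intros. destruct (tra_preimage_dep _ a H) as [s' [a' E1]].
  pose proof (f_equal (@projT1 _ _) E1) as e; simpl in e. apply ss_injective in e. subst.
  apply inj_pair2 in E1. eauto.
Qed.
End Injectivity.

Definition mf_result_eq {S3 : sig} {w1 w2 : list (srt S3)} {s1 s2 : srt S3}
  (x : (fsym S3 w1 s1 + term S3 s1)%type) (y : (fsym S3 w2 s2 + term S3 s2)%type) : Prop :=
  match x, y with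
  | inl h1, inl h2 => existT (fun w => {s & fsym S3 w s}) w1 (existT _ s1 h1) = existT _ w2 (existT _ s2 h2)
  | inr u1, inr u2 => existT (term S3) s1 u1 = existT _ s2 u2
  | _, _ => False
  end.

Definition mf_comp {S1 S2 S3} (m1 : mor S1 S2) (m2 : mor S2 S3) {w s} (f : fsym S1 w s)
  : (fsym S3 (map (ms m2) (map (ms m1) w)) (ms m2 (ms m1 s)) + term S3 (ms m2 (ms m1 s)))%type :=
  match mf m1 f with inl g => mf m2 g | inr u => inr (trt m2 u) end.

Record mor_comp {S1 S2 S3} (m1 : mor S1 S2) (m2 : mor S2 S3) (m3 : mor S1 S3) : Prop := {
  comp_ms : forall s, ms m3 s = ms m2 (ms m1 s);
  comp_mf : forall w s (f : fsym S1 w s), mf_result_eq (mf m3 f) (mf_comp m1 m2 f);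
  comp_ml : forall s (l : lab S1 s), existT (action S3) _ (ml m3 l) = existT _ _ (tra m2 (ml m1 l)) }.

Lemma app_cong S w1 w2 s1 s2 (h1 : fsym S w1 s1) (h2 : fsym S w2 s2) ts1 ts2 :
  existT (fun w => {s & fsym S w s}) w1 (existT _ s1 h1) = existT _ w2 (existT _ s2 h2) ->
  existT (terms S) w1 ts1 = existT _ w2 ts2 ->
  existT (term S) s1 (app h1 ts1) = existT _ s2 (app h2 ts2).
Proof.
  intros. dep_inv H. dep_inv H. subst. dep_inv H0. subst. reflexivity.
Qed.
Lemma tcons_cong S s1 s2 w1 w2 (t1 : term S s1) (t2 : term S s2) (ts1 : terms S w1) (ts2 : terms S w2) :
  existT (term S) s1 t1 = existT _ s2 t2 -> existT (terms S) w1 ts1 = existT _ w2 ts2 ->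
  existT (terms S) (s1 :: w1) (tcons t1 ts1) = existT _ (s2 :: w2) (tcons t2 ts2).
Proof. intros. dep_inv H. dep_inv H0. subst. reflexivity. Qed.
Lemma bin_cong S (C : forall s, action S s -> action S s -> action S s) s1 s2 a1 a2 b1 b2 :
  existT (action S) s1 a1 = existT _ s2 a2 -> existT (action S) s1 b1 = existT _ s2 b2 ->
  existT (action S) s1 (C s1 a1 b1) = existT _ s2 (C s2 a2 b2).
Proof. intros. dep_inv H. apply inj_pair2 in H0. subst. reflexivity. Qed.
Lemma un_cong S (C : forall s, action S s -> action S s) s1 s2 a1 a2 :
  existT (action S) s1 a1 = existT _ s2 a2 -> existT (action S) s1 (C s1 a1) = existT _ s2 (C s2 a2).
Proof. intros. dep_inv H. subst. reflexivity. Qed.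

Section Composition.
Context {S1 S2 S3} (m1 : mor S1 S2) (m2 : mor S2 S3) (m3 : mor S1 S3) (H : mor_comp m1 m2 m3).

Lemma trt_comp :
  (forall s (t : term S1 s), existT (term S3) _ (trt m3 t) = existT _ _ (trt m2 (trt m1 t))) /\
  (forall w (ts : terms S1 w), existT (terms S3) _ (trts m3 ts) = existT _ _ (trts m2 (trts m1 ts))).
Proof.
  apply term_terms_ind.
  - intros w s f ts IH. pose proof (comp_mf _ _ _ H w s f) as R. unfold mf_comp in R. simpl.
    destruct (mf m1 f) as [g|u]; simpl.
    + destruct (mf m3 f) as [h3|u3]; destruct (mf m2 g) as [h2|u2]; simpl in R; try contradiction.
      * apply app_cong; auto.
      * exact R.
    + destruct (mf m3 f) as [h3|u3]; simpl in R; try contradiction. exact R.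
  - reflexivity.
  - intros s w t IH ts IH2. simpl. apply tcons_cong; auto.
Qed.

Lemma tra_comp s (a : action S1 s) : existT (action S3) _ (tra m3 a) = existT _ _ (tra m2 (tra m1 a)).
Proof.
  induction a; simpl.
  - apply (comp_ml _ _ _ H).
  - rewrite (comp_ms _ _ _ H s). reflexivity.
  - rewrite (comp_ms _ _ _ H s). reflexivity.
  - apply (bin_cong _ (fun s => @aunion S3 s)); auto.
  - apply (bin_cong _ (fun s => @aimp S3 s)); auto.
  - apply (bin_cong _ (fun s => @aseq S3 s)); auto.
  - apply (bin_cong _ (fun s => @arel S3 s)); auto.
  - apply (un_cong _ (fun s => @astar S3 s)); auto.
Qed.
End Composition.

Section Retarget.
Context {T S3 : sig}.

Definition cast_mf {Z Z' : block S3} (e : Z = Z') {w s} (x : (fsym (ext S3 Z) w s + term (ext S3 Z) s)%type)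
  : (fsym (ext S3 Z') w s + term (ext S3 Z') s)%type :=
  eq_rect Z (fun Z0 => (fsym (ext S3 Z0) w s + term (ext S3 Z0) s)%type) x Z' e.
Definition cast_term {Z Z' : block S3} (e : Z = Z') {s} (x : term (ext S3 Z) s) : term (ext S3 Z') s :=
  eq_rect Z (fun Z0 => term (ext S3 Z0) s) x Z' e.
Definition cast_action {Z Z' : block S3} (e : Z = Z') {s} (x : action (ext S3 Z) s) : action (ext S3 Z') s :=
  eq_rect Z (fun Z0 => action (ext S3 Z0) s) x Z' e.

(* Needed because [mapb (ms m2) (mapb (ms m1) X)] and [mapb (ms m3) X] are only
   propositionally equal when [m3] is the composite of [m1] and [m2]. *)
Definition retarget {Z Z' : block S3} (e : Z = Z') (n : mor T (ext S3 Z)) : mor T (ext S3 Z') :=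
  Mor T (ext S3 Z') (ms n) (fun w s f => cast_mf e (mf n f)) (fun s l => cast_action e (ml n l)).

Lemma sEx_retarget Z Z' (e : Z = Z') (n : mor T (ext S3 Z)) (p : sentence T) :
  sEx Z (trs p _ n) = sEx Z' (trs p _ (retarget e n)).
Proof. destruct e. destruct n. reflexivity. Qed.
Lemma sAll_retarget Z Z' (e : Z = Z') (n : mor T (ext S3 Z)) (p : sentence T) :
  sAll Z (trs p _ n) = sAll Z' (trs p _ (retarget e n)).
Proof. destruct e. destruct n. reflexivity. Qed.
Lemma trt_retarget Z Z' (e : Z = Z') (n : mor T (ext S3 Z)) s (t : term T s) :
  trt (retarget e n) t = cast_term e (trt n t).
Proof. destruct e. destruct n. reflexivity. Qed.
Lemma tra_retarget Z Z' (e : Z = Z') (n : mor T (ext S3 Z)) s (a : action T s) :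
  tra (retarget e n) a = cast_action e (tra n a).
Proof. destruct e. destruct n. reflexivity. Qed.

Lemma cast_term_embt Z Z' (e : Z = Z') s (u : term S3 s) : cast_term e (embt Z u) = embt Z' u.
Proof. destruct e. reflexivity. Qed.
Lemma cast_action_emba Z Z' (e : Z = Z') s (a : action S3 s) : cast_action e (emba Z a) = emba Z' a.
Proof. destruct e. reflexivity. Qed.
Lemma cast_action_var Z Z' (e : Z = Z') s (v : var (snd Z) s) :
  exists v' : var (snd Z') s,
  cast_action e (@alab (ext S3 Z) s (inr v)) = @alab (ext S3 Z') s (inr v') /\ proj1_sig v' = proj1_sig v.
Proof. destruct e. exists v. auto. Qed.
End Retarget.

Lemma var_existT A (l : list A) s s' : forall (v : var l s) (v' : var l s'),
  proj1_sig v = proj1_sig v' -> existT (var l) s v = existT _ s' v'.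
Proof.
  intros [i e] [i' e'] E. simpl in E. subst i'.
  assert (s = s') by congruence. subst s'. f_equal. f_equal. apply proof_irrelevance.
Qed.

Lemma trt_lift_embt S1 S2 (m : mor S1 S2) (Y : block S1) :
  (forall s (u : term S1 s), trt (lift m Y) (embt Y u) = embt (mapb (ms m) Y) (trt m u)) /\
  (forall w (us : terms S1 w), trts (lift m Y) (embts Y us) = embts (mapb (ms m) Y) (trts m us)).
Proof.
  apply term_terms_ind.
  - intros w s f ts IH. simpl. destruct (mf m f); simpl; [rewrite IH|]; reflexivity.
  - reflexivity.
  - intros s w t IH ts IH2. simpl. rewrite IH, IH2. reflexivity.
Qed.
Lemma tra_lift_emba S1 S2 (m : mor S1 S2) (Y : block S1) s (a : action S1 s) :
  tra (lift m Y) (emba Y a) = emba (mapb (ms m) Y) (tra m a).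
Proof.
  induction a; simpl; try rewrite IHa1, IHa2; try rewrite IHa; reflexivity.
Qed.

Lemma embt_cong S (Z : block S) s1 s2 (u1 : term S s1) (u2 : term S s2) :
  existT (term S) s1 u1 = existT _ s2 u2 -> existT (term (ext S Z)) s1 (embt Z u1) = existT _ s2 (embt Z u2).
Proof. intros. dep_inv H. subst. reflexivity. Qed.
Lemma emba_cong S (Z : block S) s1 s2 (u1 : action S s1) (u2 : action S s2) :
  existT (action S) s1 u1 = existT _ s2 u2 ->
  existT (action (ext S Z)) s1 (emba Z u1) = existT _ s2 (emba Z u2).
Proof. intros. dep_inv H. subst. reflexivity. Qed.
Lemma inl_cong S (Z : block S) w1 w2 s1 s2 (h1 : fsym S w1 s1) (h2 : fsym S w2 s2) :
  existT (fun w => {s & fsym S w s}) w1 (existT _ s1 h1) = existT _ w2 (existT _ s2 h2) ->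
  existT (fun w => {s & fsym (ext S Z) w s}) w1 (existT _ s1 (inl h1)) = existT _ w2 (existT _ s2 (inl h2)).
Proof. intros. dep_inv H. dep_inv H. subst. reflexivity. Qed.

Lemma mf_result_eq_cast_embt S3 (Z Z' : block S3) (e : Z = Z') w1 w2 s1 s2 (u1 : term S3 s1) (u2 : term S3 s2) :
  existT (term S3) s1 u1 = existT _ s2 u2 ->
  mf_result_eq (inr (embt Z' u1) : (fsym (ext S3 Z') w1 s1 + term (ext S3 Z') s1)%type)
       (cast_mf e (inr (embt Z u2) : (fsym (ext S3 Z) w2 s2 + term (ext S3 Z) s2)%type)).
Proof. intros. destruct e. simpl. apply embt_cong. auto. Qed.
Lemma mf_result_eq_cast_inl S3 (Z Z' : block S3) (e : Z = Z') w1 w2 s1 s2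
  (h1 : fsym S3 w1 s1) (h2 : fsym S3 w2 s2) :
  existT (fun w => {s & fsym S3 w s}) w1 (existT _ s1 h1) = existT _ w2 (existT _ s2 h2) ->
  mf_result_eq (inl (inl h1) : (fsym (ext S3 Z') w1 s1 + term (ext S3 Z') s1)%type)
       (cast_mf e (inl (inl h2) : (fsym (ext S3 Z) w2 s2 + term (ext S3 Z) s2)%type)).
Proof. intros. destruct e. simpl. apply inl_cong. auto. Qed.
Lemma mf_result_eq_cast_var S3 (Z Z' : block S3) (e : Z = Z') s1 s2
  (v1 : var (fst Z') s1) (v2 : var (fst Z) s2) :
  proj1_sig v1 = proj1_sig v2 ->
  mf_result_eq (inl (inr v1) : (fsym (ext S3 Z') [] s1 + term (ext S3 Z') s1)%type)
       (cast_mf e (inl (inr v2) : (fsym (ext S3 Z) [] s2 + term (ext S3 Z) s2)%type)).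
Proof.
  intros. destruct e. simpl. pose proof (var_existT _ _ _ _ v1 v2 H) as E1. dep_inv E1. subst.
  reflexivity.
Qed.

Lemma mapb_comp S1 S2 S3 (m1 : mor S1 S2) (m2 : mor S2 S3) (m3 : mor S1 S3) :
  mor_comp m1 m2 m3 -> forall X, mapb (ms m2) (mapb (ms m1) X) = mapb (ms m3) X.
Proof.
  intros. unfold mapb. simpl. rewrite !map_map.
  f_equal; apply map_ext; intros; rewrite (comp_ms _ _ _ H); auto.
Qed.

Lemma mor_comp_lift S1 S2 S3 (m1 : mor S1 S2) (m2 : mor S2 S3) (m3 : mor S1 S3) (H : mor_comp m1 m2 m3) X :
  mor_comp (lift m1 X) (retarget (mapb_comp _ _ _ _ _ _ H X) (lift m2 (mapb (ms m1) X))) (lift m3 X).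
Proof.
  set (e := mapb_comp _ _ _ _ _ _ H X). constructor.
  - intros s. apply (comp_ms _ _ _ H).
  - intros w s [g|v].
    + pose proof (comp_mf _ _ _ H w s g) as R. unfold mf_comp in R |- *. simpl.
      destruct (mf m1 g) as [g2|u1]; simpl.
      * destruct (mf m3 g) as [h3|u3]; destruct (mf m2 g2) as [h2|u2]; simpl in R; try contradiction.
        -- apply mf_result_eq_cast_inl. exact R.
        -- apply mf_result_eq_cast_embt. exact R.
      * destruct (mf m3 g) as [h3|u3]; simpl in R; try contradiction. simpl.
        rewrite trt_retarget, (proj1 (trt_lift_embt _ _ _ _)), cast_term_embt.
        exact (embt_cong S3 (mapb (ms m3) X) _ _ u3 _ R).
    + destruct w; [|destruct v]. unfold mf_comp. simpl.
      exact (mf_result_eq_cast_var S3 _ _ e _ _ (mapvar (ms m3) (fst X) s v)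
        (mapvar (ms m2) (map (ms m1) (fst X)) (ms m1 s) (mapvar (ms m1) (fst X) s v)) eq_refl).
  - intros s [l0|v]; simpl.
    + rewrite tra_retarget, tra_lift_emba, cast_action_emba. apply emba_cong. apply (comp_ml _ _ _ H).
    + destruct (cast_action_var _ _ e _
          (mapvar (ms m2) (map (ms m1) (snd X)) (ms m1 s) (mapvar (ms m1) (snd X) s v))) as [v' [E1 E2]].
      simpl in E1. rewrite E1.
      pose proof (var_existT _ _ _ _ (mapvar (ms m3) (snd X) s v) v' (eq_sym E2)) as HV.
      exact (f_equal (fun p : sigT (var (map (ms m3) (snd X))) =>
        existT (action (ext S3 (mapb (ms m3) X))) (projT1 p)
           (@alab (ext S3 (mapb (ms m3) X)) _ (inr (projT2 p)))) HV).
Qed.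

Lemma sEq_cong S s1 s2 (a b : term S s1) (c d : term S s2) :
  existT (term S) s1 a = existT _ s2 c -> existT (term S) s1 b = existT _ s2 d -> sEq a b = sEq c d.
Proof. intros. dep_inv H. apply inj_pair2 in H0. subst. reflexivity. Qed.
Lemma sTr_cong S s1 s2 (x : action S s1) (y : action S s2) (a b : term S s1) (c d : term S s2) :
  existT (action S) s1 x = existT _ s2 y ->
  existT (term S) s1 a = existT _ s2 c -> existT (term S) s1 b = existT _ s2 d -> sTr x a b = sTr y c d.
Proof. intros. dep_inv H. apply inj_pair2 in H0. apply inj_pair2 in H1. subst. reflexivity. Qed.

Lemma trs_comp : forall S1 (phi : sentence S1) S2 S3 (m1 : mor S1 S2) (m2 : mor S2 S3) (m3 : mor S1 S3),
  mor_comp m1 m2 m3 -> trs phi S3 m3 = trs (trs phi S2 m1) S3 m2.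
Proof.
  apply (sentence_nested_ind (fun S1 phi => forall S2 S3 (m1 : mor S1 S2) (m2 : mor S2 S3) (m3 : mor S1 S3),
    mor_comp m1 m2 m3 -> trs phi S3 m3 = trs (trs phi S2 m1) S3 m2)).
  - intros. simpl. apply sEq_cong; apply (proj1 (trt_comp _ _ _ H)).
  - intros. simpl.
    apply sTr_cong; [apply (tra_comp _ _ _ H)|apply (proj1 (trt_comp _ _ _ H))..].
  - intros. simpl. f_equal; auto.
  - intros Sg l IH S2 S3 m1 m2 m3 H. simpl. f_equal. rewrite map_map. induction IH; simpl; f_equal; auto.
  - intros Sg l IH S2 S3 m1 m2 m3 H. simpl. f_equal. rewrite map_map. induction IH; simpl; f_equal; auto.
  - intros Sg X p IH S2 S3 m1 m2 m3 H. simpl.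
    rewrite (sEx_retarget _ _ (mapb_comp _ _ _ _ _ _ H X)). f_equal. apply IH. apply mor_comp_lift.
  - intros Sg X p IH S2 S3 m1 m2 m3 H. simpl.
    rewrite (sAll_retarget _ _ (mapb_comp _ _ _ _ _ _ H X)). f_equal. apply IH. apply mor_comp_lift.
Qed.

Lemma castw_existT S w s (f : fsym S w s) :
  existT (fun w => {s & fsym S w s}) (map (fun x => x) w) (existT _ s (castw f)) = existT _ w (existT _ s f).
Proof.
  unfold castw, eq_rect_r. generalize (eq_sym (map_id w)). generalize (map (fun x => x) w).
  intros w' e. destruct e. reflexivity.
Qed.

Lemma sf_cong Sf Sg (i : sigmor Sf Sg) w1 w2 s1 s2 (f1 : fsym Sf w1 s1) (f2 : fsym Sf w2 s2) :
  existT (fun w => {s & fsym Sf w s}) w1 (existT _ s1 f1) = existT _ w2 (existT _ s2 f2) ->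
  existT (fun w => {s & fsym Sg w s}) (map (ss i) w1) (existT _ (ss i s1) (sf i f1)) =
  existT _ (map (ss i) w2) (existT _ (ss i s2) (sf i f2)).
Proof. intros. dep_inv H. dep_inv H. subst. reflexivity. Qed.

Definition lift_sigmor {Sf Sg} (i : sigmor Sf Sg) (X : block Sf) : sigmor (ext Sf X) (ext Sg (mapb (ss i) X)) :=
  SigMor (ext Sf X) (ext Sg (mapb (ss i) X)) (ss i)
    (fun w s (f : fsym (ext Sf X) w s) => match f with
       | inl g => inl (sf i g)
       | inr v => inr (mapfvar (ss i) (fst X) w s v) end)
    (fun s (l : lab (ext Sf X) s) => match l with
       | inl l0 => inl (sl i l0)
       | inr v => inr (mapvar (ss i) (snd X) s v) end).

Lemma lift_mor_of Sf Sg (i : sigmor Sf Sg) X : lift (mor_of i) X = mor_of (lift_sigmor i X).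
Proof.
  unfold lift, mor_of. simpl. f_equal.
  - apply functional_extensionality_dep; intro w. apply functional_extensionality_dep; intro s.
    apply functional_extensionality_dep; intros [g|v]; reflexivity.
  - apply functional_extensionality_dep; intro s.
    apply functional_extensionality_dep; intros [l|v]; reflexivity.
Qed.

Lemma var_eq A (l : list A) s : forall (v v' : var l s), proj1_sig v = proj1_sig v' -> v = v'.
Proof. intros [i e] [i' e'] H. simpl in H. subst. f_equal. apply proof_irrelevance. Qed.

Lemma lift_sigmor_injective Sf Sg (i : sigmor Sf Sg) X :
  injective_sigmor i -> injective_sigmor (lift_sigmor i X).
Proof.
  intros [H1 [H2 H3]]. split; [|split].
  - exact H1.
  - intros w s [g|v] [g'|v'] H; simpl in H; try discriminate; injection H as H.
    + f_equal. apply H2. auto.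
    + f_equal. destruct w; [|destruct v]. apply var_eq. simpl in H. unfold mapvar in H.
      apply (f_equal (@proj1_sig _ _)) in H. exact H.
  - intros s [l|v] [l'|v'] H; simpl in H; try discriminate; injection H as H.
    + f_equal. apply H3. auto.
    + f_equal. apply var_eq. exact H.
Qed.

Definition incl_sigmor (Sg : sig) (X : block Sg) : sigmor Sg (ext Sg X) :=
  SigMor Sg (ext Sg X) (fun s => s) (fun w s f => inl (castw f)) (fun s l => inl l).

Lemma incl_mor_of : forall Sg X, incl Sg X = mor_of (incl_sigmor Sg X).
Proof. reflexivity. Qed.

Lemma castw_injective S w s (f f' : fsym S w s) : castw f = castw f' -> f = f'.
Proof.
  intros. pose proof (castw_existT S w s f) as E1. pose proof (castw_existT S w s f') as E2.
  rewrite H in E1. rewrite E1 in E2. apply inj_pair2 in E2. apply inj_pair2 in E2. auto.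
Qed.

Lemma incl_sigmor_injective Sg X : injective_sigmor (incl_sigmor Sg X).
Proof.
  split; [|split].
  - auto.
  - intros w s f f' H. simpl in H. injection H as H. apply castw_injective in H. auto.
  - intros s l l' H. simpl in H. injection H. auto.
Qed.

Section InclLift.
Context {Sf Sg} (i : sigmor Sf Sg) (X : block Sf).

Definition incl_then : mor Sf (ext Sg (mapb (ss i) X)) :=
  Mor Sf (ext Sg (mapb (ss i) X)) (ss i) (fun w s f => inl (inl (sf i f)))
      (fun s l => @alab (ext Sg (mapb (ss i) X)) _ (inl (sl i l))).

Lemma mor_comp_incl_lift : mor_comp (incl Sf X) (mor_of (lift_sigmor i X)) incl_then.
Proof.
  constructor.
  - reflexivity.
  - intros w s f. unfold mf_comp. simpl.
    apply (inl_cong Sg (mapb (ss i) X)). apply sf_cong. symmetry. apply castw_existT.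
  - reflexivity.
Qed.
Lemma mor_comp_mor_incl : mor_comp (mor_of i) (incl Sg (mapb (ss i) X)) incl_then.
Proof.
  constructor.
  - reflexivity.
  - intros w s f. unfold mf_comp. simpl.
    apply (inl_cong Sg (mapb (ss i) X)). symmetry. apply castw_existT.
  - reflexivity.
Qed.

Lemma trs_incl_lift : forall phi : sentence Sf,
  trs (trs phi _ (incl Sf X)) _ (mor_of (lift_sigmor i X)) =
  trs (trs phi _ (mor_of i)) _ (incl Sg (mapb (ss i) X)).
Proof. intros. rewrite <- (trs_comp _ phi _ _ _ _ _ mor_comp_incl_lift).
  apply (trs_comp _ phi _ _ _ _ _ mor_comp_mor_incl).
Qed.

Lemma trt_incl_lift s (t : term Sf s) :
  trt (mor_of (lift_sigmor i X)) (E X t) = E (mapb (ss i) X) (trt (mor_of i) t).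
Proof.
  pose proof (proj1 (trt_comp _ _ _ mor_comp_incl_lift) s t) as H1.
  pose proof (proj1 (trt_comp _ _ _ mor_comp_mor_incl) s t) as H2.
  rewrite H1 in H2. apply inj_pair2 in H2. exact H2.
Qed.
Lemma tra_incl_lift s (a : action Sf s) :
  tra (mor_of (lift_sigmor i X)) (EA X a) = EA (mapb (ss i) X) (tra (mor_of i) a).
Proof.
  pose proof (tra_comp _ _ _ mor_comp_incl_lift s a) as H1.
  pose proof (tra_comp _ _ _ mor_comp_mor_incl s a) as H2.
  rewrite H1 in H2. apply inj_pair2 in H2. exact H2.
Qed.
End InclLift.

Section InstLift.
Context {Sf Sg} (i : sigmor Sf Sg) (X : block Sf) (th' : subst Sf X) (th : subst Sg (mapb (ss i) X))
  (HF : forall s v, sub_f th (ss i s) (mapvar (ss i) (fst X) s v) = trt (mor_of i) (sub_f th' s v))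
  (HL : forall s v, sub_l th (ss i s) (mapvar (ss i) (snd X) s v) = tra (mor_of i) (sub_l th' s v)).

Definition inst_then : mor (ext Sf X) Sg :=
  Mor (ext Sf X) Sg (ss i)
    (fun w s (f : fsym (ext Sf X) w s) => match f with
      | inl g => inl (sf i g)
      | inr v => inr ((match w return fvar (fst X) w s -> term Sg (ss i s) with
                       | [] => fun v => trt (mor_of i) (sub_f th' s v)
                       | _ :: _ => fun e => match e with end end) v) end)
    (fun s (l : lab (ext Sf X) s) => match l with
      | inl l0 => alab (sl i l0)
      | inr v => tra (mor_of i) (sub_l th' s v) end).

Lemma mor_comp_inst_mor : mor_comp (subst_mor th') (mor_of i) inst_then.
Proof.
  constructor.
  - reflexivity.
  - intros w s [g|v]; unfold mf_comp; simpl.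
    + apply sf_cong. symmetry. apply castw_existT.
    + destruct w; [|destruct v]. reflexivity.
  - intros s [l|v]; reflexivity.
Qed.
Lemma mor_comp_lift_inst : mor_comp (mor_of (lift_sigmor i X)) (subst_mor th) inst_then.
Proof.
  constructor.
  - reflexivity.
  - intros w s [g|v]; unfold mf_comp; simpl.
    + symmetry. apply castw_existT.
    + destruct w; [|destruct v]. simpl. rewrite HF. reflexivity.
  - intros s [l|v]; simpl; [reflexivity|]. rewrite HL. reflexivity.
Qed.

Lemma trs_inst_lift : forall phi : sentence (ext Sf X),
  trs (inst th' phi) _ (mor_of i) = inst th (trs phi _ (mor_of (lift_sigmor i X))).
Proof.
  intros. unfold inst. rewrite <- (trs_comp _ phi _ _ _ _ _ mor_comp_inst_mor).
  apply (trs_comp _ phi _ _ _ _ _ mor_comp_lift_inst).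
Qed.
End InstLift.

Definition getEq {S} (p : sentence S) : option {s & (term S s * term S s)%type} :=
  match p with sEq t0 t1 => Some (existT _ _ (t0, t1)) | _ => None end.
Definition getTr {S} (p : sentence S) : option {s & (action S s * term S s * term S s)%type} :=
  match p with sTr a t0 t1 => Some (existT _ _ (a, t0, t1)) | _ => None end.
Definition getOr {S} (p : sentence S) : option (list (sentence S)) :=
  match p with sOr l => Some l | _ => None end.
Definition getAnd {S} (p : sentence S) : option (list (sentence S)) :=
  match p with sAnd l => Some l | _ => None end.
Definition getEx {S} (p : sentence S) : option {X : block S & sentence (ext S X)} :=
  match p with sEx X q => Some (existT _ X q) | _ => None end.
Definition getAll {S} (p : sentence S) : option {X : block S & sentence (ext S X)} :=
  match p with sAll X q => Some (existT _ X q) | _ => None end.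

Lemma mapb_injective S1 S2 (f : srt S1 -> srt S2) : (forall x y, f x = f y -> x = y) ->
  forall X Y, mapb f X = mapb f Y -> X = Y.
Proof.
  intros Hf [a b] [c d] H. unfold mapb in H. simpl in H. injection H as H1 H2.
  apply map_injective in H1; auto. apply map_injective in H2; auto. subst. reflexivity.
Qed.

Lemma trs_injective : forall Sf (phi : sentence Sf) Sg (i : sigmor Sf Sg), injective_sigmor i ->
  forall psi, trs phi Sg (mor_of i) = trs psi Sg (mor_of i) -> phi = psi.
Proof.
  apply (sentence_nested_ind (fun Sf phi => forall Sg (i : sigmor Sf Sg), injective_sigmor i ->
    forall psi, trs phi Sg (mor_of i) = trs psi Sg (mor_of i) -> phi = psi)).
  - intros Sf s t0 t1 Sg i Hi psi H. dependent destruction psi; simpl in H; try discriminate.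
    apply (f_equal getEq) in H. simpl in H. apply Some_injective in H.
    pose proof (f_equal (@projT1 _ _) H) as e. simpl in e. apply (ss_injective i Hi) in e. subst.
    apply inj_pair2 in H. injection H as H1 H2. apply (trt_injective i Hi) in H1.
    apply (trt_injective i Hi) in H2. subst. reflexivity.
  - intros Sf s a t0 t1 Sg i Hi psi H. dependent destruction psi; simpl in H; try discriminate.
    apply (f_equal getTr) in H. simpl in H. apply Some_injective in H.
    pose proof (f_equal (@projT1 _ _) H) as e. simpl in e. apply (ss_injective i Hi) in e. subst.
    apply inj_pair2 in H. injection H as H1 H2 H3. apply (tra_injective i Hi) in H1.
    apply (trt_injective i Hi) in H2. apply (trt_injective i Hi) in H3. subst. reflexivity.
  - intros Sf p q IHp IHq Sg i Hi psi H. dependent destruction psi; simpl in H; try discriminate.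
    injection H as H1 H2. apply inj_pair2 in H1. apply inj_pair2 in H2. apply IHp in H1; auto.
    apply IHq in H2; auto. subst. reflexivity.
  - intros Sf l IH Sg i Hi psi H. dependent destruction psi; simpl in H; try discriminate.
    apply (f_equal getOr) in H. simpl in H. apply Some_injective in H. f_equal.
    revert l0 H. induction IH as [|x l Hx Hl IHl]; intros [|y l'] H; simpl in H; try discriminate; auto.
    injection H as H1 H2. f_equal; [apply (Hx _ i Hi); auto|]. apply IHl; auto.
  - intros Sf l IH Sg i Hi psi H. dependent destruction psi; simpl in H; try discriminate.
    apply (f_equal getAnd) in H. simpl in H. apply Some_injective in H. f_equal.
    revert l0 H. induction IH as [|x l Hx Hl IHl]; intros [|y l'] H; simpl in H; try discriminate; auto.
    injection H as H1 H2. f_equal; [apply (Hx _ i Hi); auto|]. apply IHl; auto.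
  - intros Sf X p IH Sg i Hi psi H. dependent destruction psi; simpl in H; try discriminate.
    apply (f_equal getEx) in H. simpl in H. apply Some_injective in H.
    pose proof (f_equal (@projT1 _ _) H) as e. simpl in e.
    apply mapb_injective in e; [|apply (ss_injective i Hi)]. subst.
    apply inj_pair2 in H. rewrite !lift_mor_of in H. apply IH in H; [subst; reflexivity|].
    apply lift_sigmor_injective; auto.
  - intros Sf X p IH Sg i Hi psi H. dependent destruction psi; simpl in H; try discriminate.
    apply (f_equal getAll) in H. simpl in H. apply Some_injective in H.
    pose proof (f_equal (@projT1 _ _) H) as e. simpl in e.
    apply mapb_injective in e; [|apply (ss_injective i Hi)]. subst.
    apply inj_pair2 in H. rewrite !lift_mor_of in H. apply IH in H; [subst; reflexivity|].
    apply lift_sigmor_injective; auto.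
Qed.

Definition symbol_map {S1 S2} (j : sigmor S1 S2) (y : symbol S1) : symbol S2 :=
  match y with
  | ySort s => ySort (ss j s)
  | yFun f => yFun (sf j f)
  | yLab l => yLab (sl j l)
  end.

Lemma syms_trt S1 S2 (j : sigmor S1 S2) :
  (forall s (t : term S1 s), syms_term (trt (mor_of j) t) = map (symbol_map j) (syms_term t)) /\
  (forall w (ts : terms S1 w), syms_terms (trts (mor_of j) ts) = map (symbol_map j) (syms_terms ts)).
Proof.
  apply term_terms_ind.
  - intros w s f ts IH. simpl. f_equal. exact IH.
  - reflexivity.
  - intros s w t IH ts IH2. simpl. rewrite map_app. f_equal; [exact IH|exact IH2].
Qed.
Lemma syms_tra S1 S2 (j : sigmor S1 S2) s (a : action S1 s) :
  syms_action (tra (mor_of j) a) = map (symbol_map j) (syms_action a).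
Proof.
  induction a; simpl; try (rewrite map_app; f_equal; assumption); try assumption; reflexivity.
Qed.

Lemma base_syms_map S1 S2 (j : sigmor S1 S2) X (L : list (symbol (ext S1 X))) :
  base_syms (map (symbol_map (lift_sigmor j X)) L) = map (symbol_map j) (base_syms L).
Proof.
  unfold base_syms. induction L as [|y L IH]; [reflexivity|]. simpl. rewrite IH, map_app. f_equal.
  destruct y as [s|w s [g|v]|s [l|v]]; reflexivity.
Qed.

Lemma syms_trs : forall S1 (phi : sentence S1) S2 (j : sigmor S1 S2),
  syms (trs phi S2 (mor_of j)) = map (symbol_map j) (syms phi).
Proof.
  apply (sentence_nested_ind (fun S1 phi => forall S2 (j : sigmor S1 S2),
    syms (trs phi S2 (mor_of j)) = map (symbol_map j) (syms phi))).
  - intros. simpl. rewrite map_app. f_equal; apply (proj1 (syms_trt _ _ j)).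
  - intros. simpl. rewrite !map_app. f_equal; [apply syms_tra|]. f_equal; apply (proj1 (syms_trt _ _ j)).
  - intros. simpl. rewrite H, H0, map_app. reflexivity.
  - intros Sg l IH S2 j. simpl. induction IH; simpl; [reflexivity|]. rewrite H, IHIH, map_app.
    reflexivity.
  - intros Sg l IH S2 j. simpl. induction IH; simpl; [reflexivity|]. rewrite H, IHIH, map_app.
    reflexivity.
  - intros Sg X p IH S2 j. simpl. rewrite lift_mor_of, IH, base_syms_map, !map_app, !map_map.
    reflexivity.
  - intros Sg X p IH S2 j. simpl. rewrite lift_mor_of, IH, base_syms_map, !map_app, !map_map.
    reflexivity.
Qed.

Lemma covers_image S1 S2 (j : sigmor S1 S2) L : covers j (map (symbol_map j) L).
Proof.
  intros y Hy. apply in_map_iff in Hy as [x [E Hx]]. subst.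
  destruct x as [s|w s f|s l]; simpl.
  - eauto.
  - exists w, s, f. reflexivity.
  - exists s, l. reflexivity.
Qed.

Lemma list_preimage A B (f : A -> B) l : (forall x, In x l -> exists y, f y = x) -> exists l', map f l' = l.
Proof.
  induction l as [|a l IH]; intros H; [exists []; reflexivity|].
  destruct (H a (or_introl eq_refl)) as [y Hy]. destruct IH as [l' Hl']; [intros; apply H; right; auto|].
  exists (y :: l'). simpl. congruence.
Qed.

Lemma nth_error_map_inv A B (f : A -> B) l j b : nth_error (map f l) j = Some b ->
  exists a, nth_error l j = Some a /\ f a = b.
Proof.
  intros. rewrite nth_error_map in H. destruct (nth_error l j) as [a|]; simpl in H; [|discriminate].
  injection H. eauto.
Qed.

Lemma covers_lift Sf Sg (i : sigmor Sf Sg) X (L : list (symbol (ext Sg (mapb (ss i) X)))) :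
  covers i (base_syms L) -> covers (lift_sigmor i X) L.
Proof.
  intros HC y Hy.
  assert (HP : forall y', In y' (base_symbol y) -> in_image i y').
  { intros y' Hy'. apply HC. unfold base_syms. apply in_flat_map. eauto. }
  destruct y as [s|w s [g|v]|s [l|v]]; simpl in HP |- *.
  - apply (HP (@ySort Sg s)). auto.
  - destruct (HP (yFun g) (or_introl eq_refl)) as [w' [s' [f' Hf]]].
    exists w', s', (inl f'). exact (inl_cong Sg (mapb (ss i) X) _ _ _ _ (sf i f') g Hf).
  - destruct w; [|destruct v]. destruct v as [j E0].
    destruct (nth_error_map_inv _ _ _ _ _ _ E0) as [s' [E1 E2]]. subst s.
    exists [], s', (inr (exist _ j E1)). simpl.
    pose proof (var_existT _ (map (ss i) (fst X)) _ _
                  (mapvar (ss i) (fst X) s' (exist _ j E1)) (exist _ j E0) eq_refl) as HV.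
    exact (f_equal (fun p : sigT (var (map (ss i) (fst X))) =>
      existT (fun w => {s & fsym (ext Sg (mapb (ss i) X)) w s}) [] (existT _ (projT1 p) (inr (projT2 p)))) HV).
  - destruct (HP (yLab l) (or_introl eq_refl)) as [s' [l' Hl]].
    exists s', (inl l'). simpl.
    exact (f_equal (fun p : sigT (lab Sg) =>
                      existT (lab (ext Sg (mapb (ss i) X))) (projT1 p) (inl (projT2 p))) Hl).
  - destruct v as [j E0].
    destruct (nth_error_map_inv _ _ _ _ _ _ E0) as [s' [E1 E2]]. subst s.
    exists s', (inr (exist _ j E1)). simpl.
    pose proof (var_existT _ (map (ss i) (snd X)) _ _
                  (mapvar (ss i) (snd X) s' (exist _ j E1)) (exist _ j E0) eq_refl) as HV.
    exact (f_equal (fun p : sigT (var (map (ss i) (snd X))) =>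
      existT (lab (ext Sg (mapb (ss i) X))) (projT1 p) (inr (projT2 p))) HV).
Qed.

Lemma trs_preimage : forall Sg (phi : sentence Sg) Sf (i : sigmor Sf Sg), injective_sigmor i ->
  covers i (syms phi) -> exists phi', trs phi' Sg (mor_of i) = phi.
Proof.
  apply (sentence_nested_ind (fun Sg phi => forall Sf (i : sigmor Sf Sg), injective_sigmor i ->
    covers i (syms phi) -> exists phi', trs phi' Sg (mor_of i) = phi)).
  - intros Sg s t0 t1 Sf i Hi HC. simpl in HC. apply covers_app in HC as [H0 H1].
    destruct (proj1 (trt_preimage_dep i Hi) _ t0 H0) as [s' [t0' E0]]. dep_inv E0. subst.
    destruct (trt_preimage i Hi _ t1 H1) as [t1' E1]. subst. exists (sEq t0' t1'). reflexivity.
  - intros Sg s a t0 t1 Sf i Hi HC. simpl in HC. apply covers_app in HC as [Ha HC].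
    apply covers_app in HC as [H0 H1].
    destruct (tra_preimage_dep i Hi _ a Ha) as [s' [a' Ea]]. dep_inv Ea. subst.
    destruct (trt_preimage i Hi _ t0 H0) as [t0' E0]. destruct (trt_preimage i Hi _ t1 H1) as [t1' E1].
    subst.
    exists (sTr a' t0' t1'). reflexivity.
  - intros Sg p q IHp IHq Sf i Hi HC. simpl in HC. apply covers_app in HC as [H1 H2].
    destruct (IHp _ i Hi H1) as [p' Ep]. destruct (IHq _ i Hi H2) as [q' Eq]. subst.
    exists (sImp p' q'). reflexivity.
  - intros Sg l IH Sf i Hi HC. simpl in HC.
    assert (exists l', map (fun p => trs p Sg (mor_of i)) l' = l) as [l' El].
    { induction IH as [|x l Hx Hl IHl]; [exists []; reflexivity|]. apply covers_app in HC as [H1 H2].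
      destruct (Hx _ i Hi H1) as [x' Ex]. destruct (IHl H2) as [l' El]. exists (x' :: l'). simpl.
      congruence. }
    exists (sOr l'). simpl. congruence.
  - intros Sg l IH Sf i Hi HC. simpl in HC.
    assert (exists l', map (fun p => trs p Sg (mor_of i)) l' = l) as [l' El].
    { induction IH as [|x l Hx Hl IHl]; [exists []; reflexivity|]. apply covers_app in HC as [H1 H2].
      destruct (Hx _ i Hi H1) as [x' Ex]. destruct (IHl H2) as [l' El]. exists (x' :: l'). simpl.
      congruence. }
    exists (sAnd l'). simpl. congruence.
  - intros Sg [l1 l2] p IH Sf i Hi HC. simpl in HC. apply covers_app in HC as [HS HC].
    destruct (list_preimage _ _ (ss i) l1) as [l1' E1].
    { intros x Hx. apply (HS (ySort x)). apply in_map. apply in_or_app. auto. }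
    destruct (list_preimage _ _ (ss i) l2) as [l2' E2].
    { intros x Hx. apply (HS (ySort x)). apply in_map. apply in_or_app. auto. }
    subst l1 l2.
    destruct (IH _ (lift_sigmor i (l1', l2')) (lift_sigmor_injective _ _ _ _ Hi) (covers_lift _ _ i (l1', l2') _ HC))
      as [p' Ep].
    exists (sEx (l1', l2') p'). cbn [trs]. rewrite lift_mor_of.
    exact (f_equal (@sEx Sg (map (ss i) l1', map (ss i) l2')) Ep).
  - intros Sg [l1 l2] p IH Sf i Hi HC. simpl in HC. apply covers_app in HC as [HS HC].
    destruct (list_preimage _ _ (ss i) l1) as [l1' E1].
    { intros x Hx. apply (HS (ySort x)). apply in_map. apply in_or_app. auto. }
    destruct (list_preimage _ _ (ss i) l2) as [l2' E2].
    { intros x Hx. apply (HS (ySort x)). apply in_map. apply in_or_app. auto. }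
    subst l1 l2.
    destruct (IH _ (lift_sigmor i (l1', l2')) (lift_sigmor_injective _ _ _ _ Hi) (covers_lift _ _ i (l1', l2') _ HC))
      as [p' Ep].
    exists (sAll (l1', l2') p'). cbn [trs]. rewrite lift_mor_of.
    exact (f_equal (@sAll Sg (map (ss i) l1', map (ss i) l2')) Ep).
Qed.

Definition strip_f {S : sig} {l : list (srt S)} (p : {w & {s & (fsym S w s + fvar l w s)%type}}) :
  option {w & {s & fsym S w s}} :=
  match p with
  | existT _ w (existT _ s x) => match x with inl g => Some (existT _ w (existT _ s g)) | inr _ => None end
  end.
Definition strip_l {S : sig} {l : list (srt S)} (p : {s & (lab S s + var l s)%type}) : option {s & lab S s} :=
  match p with existT _ s x => match x with inl g => Some (existT _ s g) | inr _ => None end end.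

Lemma covers_incl_inv Sf Sg (i : sigmor Sf Sg) X (L : list (symbol Sg)) :
  covers (lift_sigmor i X) (map (symbol_map (incl_sigmor Sg (mapb (ss i) X))) L) -> covers i L.
Proof.
  intros HC y Hy. specialize (HC _ (in_map _ _ _ Hy)).
  destruct y as [s|w s f|s l]; simpl in HC |- *.
  - exact HC.
  - destruct HC as [w' [s' [[f'|v] Hf]]].
    + apply (f_equal (@strip_f Sg (map (ss i) (fst X)))) in Hf. simpl in Hf. apply Some_injective in Hf.
      exists w', s', f'. rewrite Hf. apply castw_existT.
    + apply (f_equal (@strip_f Sg (map (ss i) (fst X)))) in Hf. simpl in Hf. discriminate.
  - destruct HC as [s' [[l'|v] Hl]].
    + apply (f_equal (@strip_l Sg (map (ss i) (snd X)))) in Hl. simpl in Hl. apply Some_injective in Hl.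
      exists s', l'. exact Hl.
    + apply (f_equal (@strip_l Sg (map (ss i) (snd X)))) in Hl. simpl in Hl. discriminate.
Qed.

Lemma incl_preimage Sf Sg (i : sigmor Sf Sg) :
  injective_sigmor i -> forall X (psi : sentence (ext Sf X)) (phi : sentence Sg),
  trs psi _ (mor_of (lift_sigmor i X)) = trs phi _ (incl Sg (mapb (ss i) X)) ->
  exists phi', trs phi' Sg (mor_of i) = phi /\ psi = trs phi' _ (incl Sf X).
Proof.
  intros Hi X psi phi H.
  assert (HC : covers (lift_sigmor i X) (syms (trs phi _ (incl Sg (mapb (ss i) X))))).
  { rewrite <- H, syms_trs. apply covers_image. }
  rewrite incl_mor_of, syms_trs in HC. apply covers_incl_inv in HC.
  destruct (trs_preimage _ phi _ i Hi HC) as [phi' Ep]. exists phi'. split; auto.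
  apply (trs_injective _ psi _ (lift_sigmor i X) (lift_sigmor_injective _ _ _ _ Hi)).
  rewrite H, trs_incl_lift, Ep. reflexivity.
Qed.

Definition preimage {Sf Sg} (i : sigmor Sf Sg) (G : sset Sg) : sset Sf := fun psi => G (trs psi Sg (mor_of i)).

Lemma sset_ext S (G G' : sset S) : (forall phi, G phi <-> G' phi) -> G = G'.
Proof. intros. apply functional_extensionality. intros. apply propositional_extensionality. auto. Qed.

Section Preimage.
Context {Sf Sg} (i : sigmor Sf Sg) (Hi : injective_sigmor i).

Lemma preimage_add (P' : sentence Sf) (G : sset Sg) :
  preimage i (add (trs P' Sg (mor_of i)) G) = add P' (preimage i G).
Proof.
  apply sset_ext. intros phi. unfold preimage, add. split; intros [E|E]; auto.
  - left. apply (trs_injective _ phi _ i Hi). auto.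
  - left. subst. reflexivity.
Qed.

Lemma preimage_up X (G : sset Sg) : preimage (lift_sigmor i X) (up (mapb (ss i) X) G) = up X (preimage i G).
Proof.
  apply sset_ext. intros psi. unfold preimage, up. split.
  - intros [phi [HG E]]. destruct (incl_preimage _ _ i Hi X psi phi E) as [phi' [E1 E2]]. subst.
    exists phi'. auto.
  - intros [phi' [HG E]]. subst. exists (trs phi' Sg (mor_of i)). split; auto. apply trs_incl_lift.
Qed.

Lemma preimage_bigcup (Phi' : list (sentence Sf)) (GF : nat -> sset Sg) :
  preimage i (bigcup (map (fun p => trs p Sg (mor_of i)) Phi') GF) = bigcup Phi' (fun k => preimage i (GF k)).
Proof.
  apply sset_ext. intros psi. unfold preimage, bigcup. split.
  - intros [k [phi [E H]]]. rewrite nth_error_map in E.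
    destruct (nth_error Phi' k) as [p|] eqn:Ek; [|discriminate].
    exists k, p. auto.
  - intros [k [phi [E H]]]. exists k, (trs phi Sg (mor_of i)). rewrite nth_error_map, E. auto.
Qed.

Lemma basicset_preimage G : basicset G -> basicset (preimage i G).
Proof.
  intros H psi Hp. apply H in Hp. destruct psi; simpl in Hp |- *; auto.
  destruct a; simpl in Hp; auto.
Qed.
End Preimage.

Lemma argpair_map Sf Sg (i : sigmor Sf Sg) w (ts ts' : terms Sf w) s u u' :
  argpair Sf w ts ts' s u u' ->
  argpair Sg (map (ss i) w) (trts (mor_of i) ts) (trts (mor_of i) ts') (ss i s)
    (trt (mor_of i) u) (trt (mor_of i) u').
Proof.
  intros. induction H; simpl; constructor; auto.
Qed.

Lemma argpair_list : forall Sg w (ts ts' : terms Sg w),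
  exists L : list {s & (term Sg s * term Sg s)%type},
  forall s u u', argpair Sg w ts ts' s u u' <-> In (existT _ s (u, u')) L.
Proof.
  intros Sg w ts. induction ts as [|s w t ts IH]; intros ts'.
  - exists []. intros. split; [intros H; inversion H|intros []].
  - dependent destruction ts'. destruct (IH ts') as [L HL]. exists (existT _ s (t, t0) :: L).
    intros s' u u'. split.
    + intros H. dependent destruction H; [left; reflexivity|]. right. apply HL. auto.
    + intros [E|E].
      * dep_inv E. injection E as E1 E2. subst. constructor.
      * constructor. apply HL. auto.
Qed.

(** * Restricting derivations to subsignatures *)

Definition restrictable {Sg} (P : forall Sf, sigmor Sf Sg -> Prop) : Prop :=
  exists K, forall Sf (i : sigmor Sf Sg), injective_sigmor i -> covers i K -> P Sf i.

Lemma restrictable_forall_list {Sg} {A : Type} (L : list A) (P : A -> forall Sf, sigmor Sf Sg -> Prop) :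
  (forall a, In a L -> restrictable (P a)) ->
  restrictable (fun Sf i => forall a, In a L -> P a Sf i).
Proof.
  induction L as [|a L IH]; intros H.
  - exists []. intros ? ? ? ? ? [].
  - destruct (H a (or_introl eq_refl)) as [Ka HKa], IH as [K HK]; [intros; apply H; right; auto|].
    exists (Ka ++ K). intros Sf i Hi HC b [<-|Hb]; apply covers_app in HC as [HCa HC]; auto.
Qed.

Lemma restrictable_forall_nth {Sg} (Phi : list (sentence Sg))
  (P : nat -> sentence Sg -> forall Sf, sigmor Sf Sg -> Prop) :
  (forall k phi, nth_error Phi k = Some phi -> restrictable (P k phi)) ->
  restrictable (fun Sf i => forall k phi, nth_error Phi k = Some phi -> P k phi Sf i).
Proof.
  revert P. induction Phi as [|phi Phi IH]; intros P H.
  - exists []. intros Sf i Hi HC [|k] phi E; discriminate.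
  - destruct (H 0 phi eq_refl) as [K0 HK0], (IH (fun k => P (S k)) (fun k => H (S k))) as [K HK].
    exists (K0 ++ K). intros Sf i Hi HC [|k] psi E; apply covers_app in HC as [HC0 HC].
    + injection E as <-. auto.
    + exact (HK Sf i Hi HC k psi E).
Qed.

Lemma trt_app_preimage Sf Sg (i : sigmor Sf Sg) : injective_sigmor i ->
  forall s (t1 t2 : term Sf s) w (f : fsym Sg w (ss i s)) ts ts',
  trt (mor_of i) t1 = app f ts -> trt (mor_of i) t2 = app f ts' ->
  exists w' (f' : fsym Sf w' s) ts1 ts2, t1 = app f' ts1 /\ t2 = app f' ts2 /\
    existT (fun w => (fsym Sg w (ss i s) * terms Sg w * terms Sg w)%type) (map (ss i) w')
      (sf i f', trts (mor_of i) ts1, trts (mor_of i) ts2)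
    = existT _ w (f, ts, ts').
Proof.
  intros Hi s t1 t2 w f ts ts' E1 E2.
  destruct t1 as [w1 s1 f1 ts1]. destruct t2 as [w2 s2 f2 ts2]. simpl in E1, E2.
  apply (f_equal term_head) in E1. apply (f_equal term_head) in E2. simpl in E1, E2.
  dep_inv E1. pose proof (f_equal fst E1) as Ef1. pose proof (f_equal snd E1) as Et1. simpl in Ef1, Et1.
  subst.
  pose proof (f_equal (@projT1 _ _) E2) as e2. simpl in e2.
  apply (map_ss_injective i Hi) in e2. subst. apply inj_pair2 in E2.
  pose proof (f_equal fst E2) as Ef2. pose proof (f_equal snd E2) as Et2. simpl in Ef2, Et2.
  apply (proj1 (proj2 Hi)) in Ef2. subst.
  exists w1, f1, ts1, ts2. split; auto.
Qed.

Fixpoint allvars {A} (l : list A) : list {s : A & var l s} :=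
  match l return list {s : A & var l s} with
  | [] => []
  | a :: l' => existT _ a (exist (fun i => nth_error (a :: l') i = Some a) 0 eq_refl) ::
      map (fun p => existT (fun s => var (a :: l') s) (projT1 p)
             (exist (fun i => nth_error (a :: l') i = Some (projT1 p))
                 (S (proj1_sig (projT2 p))) (proj2_sig (projT2 p))))
          (allvars l')
  end.

Lemma allvars_in A (l : list A) : forall s (v : var l s), In (existT _ s v) (allvars l).
Proof.
  induction l as [|a l IH]; intros s [j e].
  - destruct j; discriminate e.
  - destruct j as [|j].
    + simpl in e. injection e as e'. subst. left. f_equal. f_equal. apply proof_irrelevance.
    + right. simpl. apply in_map_iff. exists (existT _ s (exist _ j e)). split; auto.
Qed.

Definition syms_subst {Sg X} (th : subst Sg X) : list (symbol Sg) :=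
  flat_map (fun p => syms_term (sub_f th (projT1 p) (projT2 p))) (allvars (fst X)) ++
  flat_map (fun p => syms_action (sub_l th (projT1 p) (projT2 p))) (allvars (snd X)).

Lemma subst_preimage Sf Sg (i : sigmor Sf Sg) : injective_sigmor i -> forall X (th : subst Sg (mapb (ss i) X)),
  covers i (syms_subst th) ->
  exists th' : subst Sf X,
    (forall s v, sub_f th (ss i s) (mapvar (ss i) (fst X) s v) = trt (mor_of i) (sub_f th' s v)) /\
    (forall s v, sub_l th (ss i s) (mapvar (ss i) (snd X) s v) = tra (mor_of i) (sub_l th' s v)).
Proof.
  intros Hi X th HC. unfold syms_subst in HC. apply covers_app in HC as [H1 H2].
  assert (Ef : forall s (v : var (fst X) s),
             {t' : term Sf s | trt (mor_of i) t' = sub_f th (ss i s) (mapvar (ss i) (fst X) s v)}).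
  { intros s v. apply constructive_indefinite_description. apply (trt_preimage i Hi).
    intros y Hy. apply H1. apply in_flat_map. exists (existT _ _ (mapvar (ss i) (fst X) s v)).
    split; auto.
    apply allvars_in. }
  assert (El : forall s (v : var (snd X) s),
             {a' : action Sf s | tra (mor_of i) a' = sub_l th (ss i s) (mapvar (ss i) (snd X) s v)}).
  { intros s v. apply constructive_indefinite_description. apply (tra_preimage i Hi).
    intros y Hy. apply H2. apply in_flat_map. exists (existT _ _ (mapvar (ss i) (snd X) s v)).
    split; auto.
    apply allvars_in. }
  exists (Subst Sf X (fun s v => proj1_sig (Ef s v)) (fun s v => proj1_sig (El s v))). simpl. split.
  - intros. symmetry. exact (proj2_sig (Ef s v)).
  - intros. symmetry. exact (proj2_sig (El s v)).
Qed.

Lemma vx1_tr Sf Sg (i : sigmor Sf Sg) x : trt (mor_of (lift_sigmor i (b1 x))) (vx1 x) = vx1 (ss i x).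
Proof. unfold vx1, vx, vy, vz, vt. simpl. f_equal. f_equal. apply var_eq. reflexivity. Qed.
Lemma vx_tr Sf Sg (i : sigmor Sf Sg) x : trt (mor_of (lift_sigmor i (b3 x))) (vx x) = vx (ss i x).
Proof. unfold vx1, vx, vy, vz, vt. simpl. f_equal. f_equal. apply var_eq. reflexivity. Qed.
Lemma vy_tr Sf Sg (i : sigmor Sf Sg) x : trt (mor_of (lift_sigmor i (b3 x))) (vy x) = vy (ss i x).
Proof. unfold vx1, vx, vy, vz, vt. simpl. f_equal. f_equal. apply var_eq. reflexivity. Qed.
Lemma vz_tr Sf Sg (i : sigmor Sf Sg) x : trt (mor_of (lift_sigmor i (b3 x))) (vz x) = vz (ss i x).
Proof. unfold vx1, vx, vy, vz, vt. simpl. f_equal. f_equal. apply var_eq. reflexivity. Qed.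

Lemma preimage_cup Sf Sg (i : sigmor Sf Sg) (A B : sset Sg) :
  preimage i (cup A B) = cup (preimage i A) (preimage i B).
Proof. reflexivity. Qed.

Lemma list_trs_preimage Sg Sf (i : sigmor Sf Sg) : injective_sigmor i -> forall L : list (sentence Sg),
  covers i (flat_map syms L) -> exists L', map (fun p => trs p Sg (mor_of i)) L' = L.
Proof.
  intros Hi L. induction L as [|a L IH]; intros HC; [exists []; reflexivity|].
  simpl in HC. apply covers_app in HC as [H1 H2]. destruct (trs_preimage _ a _ i Hi H1) as [a' Ea].
  destruct (IH H2) as [L' EL]. exists (a' :: L'). simpl. congruence.
Qed.

Lemma syms_sOr (Sg : sig) (Phi : list (sentence Sg)) : syms (sOr Phi) = flat_map syms Phi.
Proof. induction Phi as [|phi Phi IH]; simpl; [reflexivity|]. f_equal. Qed.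

Lemma syms_sAnd (Sg : sig) (Phi : list (sentence Sg)) : syms (sAnd Phi) = flat_map syms Phi.
Proof. induction Phi as [|phi Phi IH]; simpl; [reflexivity|]. f_equal. Qed.

Lemma in_map_trs_inv (Sf Sg : sig) (i : sigmor Sf Sg) (Hi : injective_sigmor i) p L :
  In (trs p Sg (mor_of i)) (map (fun q => trs q Sg (mor_of i)) L) -> In p L.
Proof. intros H. apply in_map_iff in H as [q [E Hq]]. apply (trs_injective _ q _ i Hi) in E. subst.
  exact Hq.
Qed.

Lemma block_preimage Sf Sg (i : sigmor Sf Sg) : forall (X : block Sg),
  covers i (map ySort (fst X ++ snd X)) -> exists X', mapb (ss i) X' = X.
Proof.
  intros [l1 l2] HS. simpl in HS.
  destruct (list_preimage _ _ (ss i) l1) as [l1' E1].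
  { intros x Hx. apply (HS (ySort x)). apply in_map. apply in_or_app. auto. }
  destruct (list_preimage _ _ (ss i) l2) as [l2' E2].
  { intros x Hx. apply (HS (ySort x)). apply in_map. apply in_or_app. auto. }
  exists (l1', l2'). unfold mapb. simpl. congruence.
Qed.

(* [tra_incl_lift] and [trt_incl_lift] at the blocks of the eigenvariable rules, with
   [mapb (ss i) (b1 x)] written as [b1 (ss i x)] so that they apply as rewrite rules. *)
Section Eigen.
Context {Sf Sg : sig} (i : sigmor Sf Sg) (x : srt Sf).

Lemma tra_incl_lift_b1 s (a : action Sf s) :
  tra (mor_of (lift_sigmor i (b1 x))) (EA (b1 x) a) = @EA Sg (b1 (ss i x)) (ss i s) (tra (mor_of i) a).
Proof. exact (tra_incl_lift i (b1 x) s a). Qed.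

Lemma trt_incl_lift_b1 s (t : term Sf s) :
  trt (mor_of (lift_sigmor i (b1 x))) (E (b1 x) t) = @E Sg (b1 (ss i x)) (ss i s) (trt (mor_of i) t).
Proof. exact (trt_incl_lift i (b1 x) s t). Qed.

Lemma tra_incl_lift_b3 s (a : action Sf s) :
  tra (mor_of (lift_sigmor i (b3 x))) (EA (b3 x) a) = @EA Sg (b3 (ss i x)) (ss i s) (tra (mor_of i) a).
Proof. exact (tra_incl_lift i (b3 x) s a). Qed.
End Eigen.

Ltac split_covers :=
  repeat match goal with
  | H : covers _ (_ ++ _) |- _ => apply covers_app in H as [? ?]
  | H : covers _ (_ :: _) |- _ => apply covers_cons in H as [? ?]
  end.

Ltac use_restrictions i Hi :=
  repeat match goal with
  | HK : forall Sf (j : sigmor Sf _), injective_sigmor j -> covers j ?K -> _, H : covers i ?K |- _ =>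
      specialize (HK _ i Hi H)
  end.

Ltac pull_back i Hi :=
  repeat match goal with
  | H : covers i (syms_term ?t) |- _ =>
      is_var t;
      first [ let u := fresh "u" in destruct (trt_preimage i Hi _ t H) as [u ?]; subst t
            | let s' := fresh "s" in let u := fresh "u" in let E := fresh "E" in
              destruct (proj1 (trt_preimage_dep i Hi) _ t H) as [s' [u E]]; dep_inv E; subst t ]
  | H : covers i (syms_action ?a) |- _ =>
      is_var a;
      first [ let c := fresh "c" in destruct (tra_preimage i Hi _ a H) as [c ?]; subst a
            | let s' := fresh "s" in let c := fresh "c" in let E := fresh "E" in
              destruct (tra_preimage_dep i Hi _ a H) as [s' [c E]]; dep_inv E; subst a ]
  | H : in_image i (@yLab _ _ ?l) |- _ =>
      is_var l; let s' := fresh "s" in let l' := fresh "l" in let E := fresh "E" in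
      destruct H as [s' [l' E]];
      let e := fresh "e" in pose proof (f_equal (@projT1 _ _) E) as e; simpl in e;
      try apply (ss_injective i Hi) in e; subst; apply inj_pair2 in E; subst l
  | H : covers i (syms ?phi) |- _ =>
      is_var phi; let p := fresh "p" in destruct (trs_preimage _ phi _ i Hi H) as [p ?]; subst phi
  | H : covers i (flat_map syms ?Phi) |- _ =>
      is_var Phi; let Ps := fresh "Phi" in destruct (list_trs_preimage _ _ i Hi Phi H) as [Ps ?]; subst Phi
  | H : covers i (map ySort (fst ?X ++ snd ?X)) |- _ =>
      is_var X; let Y := fresh "X" in destruct (block_preimage _ _ i X H) as [Y ?]; subst X
  | H : covers i (base_syms (syms ?phi)) |- _ =>
      is_var phi;
      lazymatch type of phi with
      | sentence (ext _ (mapb _ ?Y)) =>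
          let p := fresh "p" in
          destruct (trs_preimage _ phi _ (lift_sigmor i Y) (lift_sigmor_injective _ _ i Y Hi)
                      (covers_lift _ _ i Y _ H)) as [p ?];
          subst phi
      end
  end.

Ltac use_lifted_restriction i Hi Y :=
  match goal with
  | HK : forall Sf (j : sigmor Sf _), injective_sigmor j -> covers j ?K -> _,
    Hc : covers i (base_syms ?K) |- _ =>
      specialize (HK _ (lift_sigmor i Y) (lift_sigmor_injective _ _ i Y Hi) (covers_lift _ _ i Y K Hc))
  end.

Ltac lift_restriction_b1 i Hi :=
  match goal with
  | HK : forall Sf (j : sigmor Sf (ext _ (b1 (ss i ?x)))), _ |- _ =>
      use_lifted_restriction i Hi (b1 x);
      rewrite <- ?(tra_incl_lift_b1 i x), <- ?(trt_incl_lift_b1 i x), <- ?(vx1_tr _ _ i x) in HK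
  end.

Ltac lift_restriction_b3 i Hi :=
  match goal with
  | HK : forall Sf (j : sigmor Sf (ext _ (b3 (ss i ?x)))), _ |- _ =>
      use_lifted_restriction i Hi (b3 x);
      rewrite <- ?(tra_incl_lift_b3 i x), <- ?(vx_tr _ _ i x), <- ?(vy_tr _ _ i x), <- ?(vz_tr _ _ i x) in HK
  end.

(* [restrict_by K] witnesses [restrictable] with [K] and the symbol lists of the induction
   hypotheses, then replaces every term, action, label, sentence and quantifier block whose symbols
   are covered by [i] by the translation of a preimage. *)
Ltac restrict_by K :=
  let rec gather acc :=
    lazymatch goal with
    | IH : @restrictable (ext _ _) _ |- _ =>
        let K' := fresh "K" in let HK := fresh "HK" in destruct IH as [K' HK]; gather (acc ++ base_syms K')
    | IH : restrictable _ |- _ =>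
        let K' := fresh "K" in let HK := fresh "HK" in destruct IH as [K' HK]; gather (acc ++ K')
    | _ => exists acc
    end in
  gather K; intros Sf i Hi HC; rewrite ?syms_sOr, ?syms_sAnd in HC; simpl syms in HC;
  split_covers; use_restrictions i Hi; pull_back i Hi.

Ltac reify_term t :=
  lazymatch t with
  | trt _ ?u => u
  | app (sf _ ?f) (trts _ ?us) => constr:(app f us)
  end.

Ltac reify_action a :=
  lazymatch a with
  | tra _ ?c => c
  | alab (sl _ ?l) => constr:(alab l)
  | azero (ss _ ?x) => constr:(azero x)
  | aone (ss _ ?x) => constr:(aone x)
  | aunion ?a0 ?a1 => let c0 := reify_action a0 in let c1 := reify_action a1 in constr:(aunion c0 c1)
  | aimp ?a0 ?a1 => let c0 := reify_action a0 in let c1 := reify_action a1 in constr:(aimp c0 c1)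
  | aseq ?a0 ?a1 => let c0 := reify_action a0 in let c1 := reify_action a1 in constr:(aseq c0 c1)
  | arel ?a0 ?a1 => let c0 := reify_action a0 in let c1 := reify_action a1 in constr:(arel c0 c1)
  | astar ?a0 => let c0 := reify_action a0 in constr:(astar c0)
  end.

Ltac reify_sentence phi :=
  lazymatch phi with
  | trs ?p _ _ => p
  | sEq ?t0 ?t1 => let u0 := reify_term t0 in let u1 := reify_term t1 in constr:(sEq u0 u1)
  | sTr ?a ?t0 ?t1 =>
      let c := reify_action a in let u0 := reify_term t0 in let u1 := reify_term t1 in constr:(sTr c u0 u1)
  | sImp ?p ?q => let p' := reify_sentence p in let q' := reify_sentence q in constr:(sImp p' q')
  | sOr (map _ ?l) => constr:(sOr l)
  | sAnd (map _ ?l) => constr:(sAnd l)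
  | sEx (mapb _ ?Y) (trs ?p _ _) => constr:(sEx Y p)
  | sAll (mapb _ ?Y) (trs ?p _ _) => constr:(sAll Y p)
  end.

Ltac injective_proof j :=
  match goal with
  | H : injective_sigmor j |- _ => H
  | _ => lazymatch j with
         | lift_sigmor ?i ?Y => let H := injective_proof i in constr:(lift_sigmor_injective _ _ i Y H)
         end
  end.

(* Rewrites [preimage j (add X G)] to [add P (preimage j G)], reading off [P] with [trs P = X]
   from the shape of [X]. *)
Ltac simpl_preimage :=
  repeat first
  [ progress rewrite ?preimage_cup, ?preimage_bigcup in *
  | match goal with
    | |- context [preimage ?j (add ?X _)] =>
        let P := reify_sentence X in let Hj := injective_proof j in rewrite (preimage_add j Hj P)
    | H : context [preimage ?j (add ?X _)] |- _ =>
        let P := reify_sentence X in let Hj := injective_proof j in rewrite (preimage_add j Hj P) in H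
    | H : context [preimage (lift_sigmor ?j ?Y) (up _ ?G)] |- _ =>
        let Hj := injective_proof j in
        change (preimage (lift_sigmor j Y) (up _ G))
          with (preimage (lift_sigmor j Y) (up (mapb (ss j) Y) G)) in H;
        rewrite (preimage_up j Hj Y G) in H
    end ].

Lemma bderiv_restrictable (Sg : sig) G D :
  bderiv Sg G D -> restrictable (fun Sf i => bderiv Sf (preimage i G) (preimage i D)).
Proof.
  induction 1.
  - restrict_by (syms phi). simpl_preimage. apply b_init.
  - restrict_by (syms_term t). simpl_preimage. apply b_refl.
  - restrict_by (syms (sEq t t')). simpl_preimage. apply b_sym. assumption.
  - restrict_by (syms (sEq t1 t2) ++ syms_term t3). simpl_preimage. eapply b_trans; eassumption.
  - destruct (argpair_list Sg w ts ts') as [L HL].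
    assert (IH : restrictable (fun Sf i => forall p, In p L ->
      bderiv Sf (preimage i G) (preimage i (add (sEq (fst (projT2 p)) (snd (projT2 p))) D)))).
    { apply restrictable_forall_list. intros [s' [u u']] Hp. apply HL in Hp. exact (H0 _ _ _ Hp). }
    restrict_by (syms_term (app f ts) ++ syms_term (app f ts')).
    destruct (proj1 (trt_preimage_dep i Hi) _ (app f ts) ltac:(assumption)) as [s1 [t1 E1]].
    dep_inv E1. destruct (trt_preimage i Hi _ (app f ts') ltac:(assumption)) as [t2 E2].
    destruct (trt_app_preimage _ _ i Hi _ t1 t2 _ f ts ts' E1 E2) as [w' [f' [ts1 [ts2 [-> [-> E]]]]]].
    dep_inv E. injection E as <- <- <-.
    simpl_preimage. apply b_cong. intros s' u u' Hp.
    specialize (HK _ (proj1 (HL _ _ _) (argpair_map _ _ i _ _ _ _ _ _ Hp))).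
    simpl in HK. simpl_preimage. exact HK.
  - restrict_by (syms (sTr (alab l) t0 t1) ++ syms_term t0' ++ syms_term t1'). simpl_preimage.
    eapply b_repl; eassumption.
Qed.

Lemma deriv_restrictable (Sg : sig) G D :
  deriv Sg G D -> restrictable (fun Sf i => deriv Sf (preimage i G) (preimage i D)).
Proof.
  induction 1.
  - destruct (bderiv_restrictable _ _ _ H1) as [K HK]. exists K. intros Sf i Hi HC. simpl_preimage.
    apply d_atom; [apply basicset_preimage; auto|apply basicset_preimage; auto|apply HK; auto].
  - restrict_by (syms_term t0 ++ syms_term t1). simpl_preimage. apply d_zero.
  - restrict_by (syms (sTr (aunion a0 a1) t0 t1)). simpl_preimage. apply d_unionL; assumption.
  - restrict_by (syms (sTr (aunion a0 a1) t0 t1)). simpl_preimage. apply d_unionR0; assumption.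
  - restrict_by (syms (sTr (aunion a0 a1) t0 t1)). simpl_preimage. apply d_unionR1; assumption.
  - restrict_by (syms (sTr (aimp a0 a1) t0 t1)). simpl_preimage. apply d_aimpL; assumption.
  - restrict_by (syms (sTr (aimp a0 a1) t0 t1)). simpl_preimage. apply d_aimpR; assumption.
  - restrict_by (syms_term t0 ++ syms_term t1). simpl_preimage. apply d_oneL; assumption.
  - restrict_by (syms_term t0 ++ syms_term t1). simpl_preimage. apply d_oneR; assumption.
  - restrict_by (syms (sTr (aseq a0 a1) t0 t1)). lift_restriction_b1 i Hi. simpl_preimage.
    apply d_seqL; assumption.
  - restrict_by (syms (sTr (aseq a0 a1) t0 t1) ++ syms_term t). simpl_preimage.
    eapply d_seqR; eassumption.
  - restrict_by (syms (sTr (arel a0 a1) t0 t1)). lift_restriction_b1 i Hi. simpl_preimage.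
    apply d_relL; assumption.
  - restrict_by (syms (sTr (arel a0 a1) t0 t1) ++ syms_term t). simpl_preimage.
    eapply d_relR; eassumption.
  - restrict_by (syms phi ++ syms psi). simpl_preimage. apply d_impL; assumption.
  - restrict_by (syms phi ++ syms psi). simpl_preimage. apply d_impR; assumption.
  - pose proof (restrictable_forall_nth Phi _ H0) as IH. restrict_by (syms (sOr Phi)). simpl_preimage.
    apply d_orL. intros k phi Ek.
    specialize (HK k (trs phi Sg (mor_of i)) ltac:(rewrite nth_error_map, Ek; reflexivity)).
    simpl_preimage. exact HK.
  - restrict_by (syms (sOr Phi) ++ syms phi). simpl_preimage.
    apply d_orR with p; [exact (in_map_trs_inv _ _ i Hi _ _ H)|assumption].
  - restrict_by (syms (sAnd Phi) ++ syms phi). simpl_preimage.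
    apply d_andL with p; [exact (in_map_trs_inv _ _ i Hi _ _ H)|assumption].
  - pose proof (restrictable_forall_nth Phi _ H0) as IH. restrict_by (syms (sAnd Phi)). simpl_preimage.
    apply d_andR. intros k phi Ek.
    specialize (HK k (trs phi Sg (mor_of i)) ltac:(rewrite nth_error_map, Ek; reflexivity)).
    simpl_preimage. exact HK.
  - restrict_by (syms (sEx X phi)). use_lifted_restriction i Hi X0.
    rewrite <- lift_mor_of. simpl_preimage. apply d_exL. assumption.
  - restrict_by (syms (sEx X phi) ++ syms_subst th).
    destruct (subst_preimage _ _ i Hi X0 th ltac:(assumption)) as [th' [HF HL]].
    rewrite <- (trs_inst_lift i X0 th' th HF HL) in HK.
    rewrite <- lift_mor_of. simpl_preimage. eapply d_exR. eassumption.
  - restrict_by (syms (sAll X phi) ++ syms_subst th).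
    destruct (subst_preimage _ _ i Hi X0 th ltac:(assumption)) as [th' [HF HL]].
    rewrite <- (trs_inst_lift i X0 th' th HF HL) in HK.
    rewrite <- lift_mor_of. simpl_preimage. eapply d_allL. eassumption.
  - restrict_by (syms (sAll X phi)). use_lifted_restriction i Hi X0.
    rewrite <- lift_mor_of. simpl_preimage. apply d_allR. assumption.
  - restrict_by (syms (sTr (astar a) t0 t1)). simpl_preimage. apply d_starAx.
  - restrict_by (syms (sTr (astar a) t0 t1)). simpl_preimage. eapply d_starCut; eassumption.
  - restrict_by (syms (sTr (astar a) t0 t1)). simpl_preimage. apply d_starR0; assumption.
  - restrict_by (syms (sTr (astar a) t0 t1) ++ syms_term t). simpl_preimage.
    eapply d_starR1; eassumption.
  - restrict_by (syms (sTr (astar a) t0 t1) ++ syms_term t). simpl_preimage.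
    eapply d_starR2; eassumption.
  - restrict_by (syms (sTr (astar a) t0 t1) ++ syms_action tt ++ syms_term t).
    lift_restriction_b3 i Hi. simpl_preimage. eapply d_starIndL; eassumption.
  - restrict_by (syms (sTr (astar a) t0 t1) ++ syms_action tt ++ syms_term t).
    lift_restriction_b3 i Hi. simpl_preimage. eapply d_starIndR; eassumption.
Qed.

(** * Finitely many side sentences *)

Definition finite {S} (G : sset S) := exists L : list (sentence S), forall phi, G phi <-> In phi L.
Definition subset {S} (G G' : sset S) := forall phi, G phi -> G' phi.
Definition inter {S} (A B : sset S) : sset S := fun phi => A phi /\ B phi.
Definition up_inv {Sg} (X : block Sg) (B : sset Sg) (A : sset (ext Sg X)) : sset Sg :=
  fun phi => B phi /\ A (trs phi _ (incl Sg X)).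
Definition emptyset {S} : sset S := fun _ => False.

Lemma finite_emptyset S : finite (@emptyset S).
Proof. exists []. unfold emptyset. simpl. tauto. Qed.
Lemma finite_add S (P : sentence S) G : finite G -> finite (add P G).
Proof. intros [L HL]. exists (P :: L). unfold add. simpl. intros. rewrite HL. intuition. Qed.
Lemma finite_cup S (A B : sset S) : finite A -> finite B -> finite (cup A B).
Proof. intros [L1 H1] [L2 H2]. exists (L1 ++ L2). unfold cup. intros. rewrite in_app_iff, H1, H2. tauto.
Qed.
Lemma finite_subset S (A B : sset S) : finite A -> subset B A -> finite B.
Proof.
  intros [L HL] Hs.
  assert (exists L', forall phi, In phi L' <-> In phi L /\ B phi) as [L' HL'].
  { clear HL. induction L as [|a L IH]; [exists []; simpl; tauto|]. destruct IH as [L' HL'].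
    destruct (classic (B a)) as [Hb|Hb].
    - exists (a :: L'). intros. simpl. rewrite HL'. intuition; subst; auto.
    - exists L'. intros. simpl. rewrite HL'. intuition; subst; tauto. }
  exists L'. intros. rewrite HL'. rewrite <- HL. split; [intros; split; auto|tauto].
Qed.
Lemma finite_inter S (A B : sset S) : finite A -> finite (inter A B).
Proof. intros. apply (finite_subset _ A); auto. unfold subset, inter. tauto. Qed.
Lemma finite_up Sg X (A : sset Sg) : finite A -> finite (up X A).
Proof.
  intros [L HL]. exists (map (fun p => trs p _ (incl Sg X)) L). intros psi. unfold up.
  rewrite in_map_iff. split; intros [phi [H1 H2]]; exists phi; split; auto; apply HL; auto.
Qed.
Lemma finite_up_inv Sg X (B : sset Sg) (A : sset (ext Sg X)) : finite A -> finite (up_inv X B A).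
Proof.
  intros [L HL].
  assert (exists L', forall phi, In phi L' <-> B phi /\ In (trs phi _ (incl Sg X)) L) as [L' HL'].
  { clear HL. induction L as [|a L IH].
    - exists []. simpl. tauto.
    - destruct IH as [L' HL'].
      destruct (classic (exists phi, B phi /\ trs phi _ (incl Sg X) = a)) as [[phi [Hb Ea]]|Hn].
      + exists (phi :: L'). intros q. simpl. rewrite HL'. split.
        * intros [E|[H1 H2]]; [subst; auto|auto].
        * intros [H1 [E|H2]]; auto. left. rewrite incl_mor_of in *.
          apply (trs_injective _ phi _ _ (incl_sigmor_injective Sg X)). congruence.
      + exists L'. intros q. simpl. rewrite HL'. split; [tauto|].
        intros [H1 [E|H2]]; auto. exfalso. apply Hn. exists q. auto. }
  exists L'. intros phi. unfold up_inv. rewrite HL', HL. tauto.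
Qed.
Lemma finite_iff (Sg : sig) (A B : sset Sg) : (forall phi, A phi <-> B phi) -> finite A -> finite B.
Proof. intros H [L HL]. exists L. intros phi. rewrite <- H. apply HL. Qed.

Lemma finite_bigcup (Sg : sig) (Phi : list (sentence Sg)) GF :
  (forall k phi, nth_error Phi k = Some phi -> finite (GF k)) -> finite (bigcup Phi GF).
Proof.
  revert GF. induction Phi as [|phi Phi IH]; intros GF H.
  - exists []. intros psi. split; [intros [[|k] [p [E _]]]; discriminate|intros []].
  - apply (finite_iff _ (cup (GF 0) (bigcup Phi (fun k => GF (S k))))).
    + intros psi. unfold cup, bigcup. split.
      * intros [Hg|[k [p [Ek Hg]]]]; [exists 0, phi; auto|exists (S k), p; auto].
      * intros [[|k] [p [Ek Hg]]]; [left; exact Hg|right; exists k, p; auto].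
    + apply finite_cup; [exact (H 0 phi eq_refl)|apply IH; intros k p Ek; exact (H (S k) p Ek)].
Qed.

Lemma add_absorb (Sg : sig) (A : sset Sg) a : A a -> add a A = A.
Proof. intros Ha. apply sset_ext. intros phi. unfold add. split; [intros [->|H]|]; auto. Qed.

Lemma add_inter_eq {Sg} {A B X : sset Sg} {a} :
  subset (add a X) A -> subset A (add a B) -> A = add a (inter A B).
Proof.
  intros Hl Hu. apply sset_ext. intros phi. unfold add, inter. split.
  - intros Hp. destruct (Hu phi Hp); auto.
  - intros [->|[H _]]; [apply Hl; left|]; auto.
Qed.

Lemma up_up_inv_eq {Sg X} {A : sset (ext Sg X)} {B : sset Sg} :
  subset A (up X B) -> A = up X (up_inv X B A).
Proof.
  intros Hu. apply sset_ext. intros psi. unfold up, up_inv. split.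
  - intros Hp. destruct (Hu psi Hp) as [phi [Hb ->]]. exists phi. auto.
  - intros [phi [[Hb Ha] ->]]. exact Ha.
Qed.

Lemma add_up_eq {Sg X} {A Y : sset (ext Sg X)} {B : sset Sg} {a} :
  subset (add a Y) A -> subset A (add a (up X B)) -> A = add a (up X (up_inv X B A)).
Proof.
  intros Hl Hu. apply sset_ext. intros psi. unfold up, up_inv, add. split.
  - intros Hp. destruct (Hu psi Hp) as [E|[phi [Hb ->]]]; auto. right. exists phi. auto.
  - intros [->|[phi [[Hb Ha] ->]]]; [apply Hl; left|]; auto.
Qed.

Lemma add2_up_eq {Sg X} {A Y : sset (ext Sg X)} {B : sset Sg} {a b} :
  subset (add a (add b Y)) A -> subset A (add a (add b (up X B))) ->
  A = add a (add b (up X (up_inv X B A))).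
Proof.
  intros Hl Hu. apply sset_ext. intros psi. unfold up, up_inv, add. split.
  - intros Hp. destruct (Hu psi Hp) as [E|[E|[phi [Hb ->]]]]; auto. right. right. exists phi. auto.
  - intros [->|[->|[phi [[Hb Ha] ->]]]]; [apply Hl; left|apply Hl; right; left|]; auto.
Qed.

Lemma subset_add_mono {Sg} {D D' : sset Sg} {a} b : subset (add a D) D' -> subset (add b D) (add b D').
Proof. intros H phi [->|Hp]; [left|right; apply H; right]; auto. Qed.

Lemma bderiv_weak Sg G D : bderiv Sg G D -> forall G' D', subset G G' -> subset D D' -> bderiv Sg G' D'.
Proof.
  induction 1; intros G' D' HG HD;
    match goal with |- bderiv _ _ ?D' =>
      match type of HD with subset (add ?P _) _ =>
        rewrite <- (add_absorb _ D' P) by (apply HD; left; reflexivity) end end.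
  - rewrite <- (add_absorb _ G' phi) by (apply HG; left; reflexivity). apply b_init.
  - apply b_refl.
  - apply b_sym, IHbderiv; [exact HG|exact (subset_add_mono _ HD)].
  - apply b_trans with (t2 := t2);
      [apply IHbderiv1|apply IHbderiv2]; solve [exact HG|exact (subset_add_mono _ HD)].
  - apply b_cong. intros s0 u u' Hap. apply (H0 _ _ _ Hap); [exact HG|exact (subset_add_mono _ HD)].
  - apply b_repl with (t0 := t0) (t1 := t1); [apply IHbderiv1|apply IHbderiv2|apply IHbderiv3];
      solve [exact HG|exact (subset_add_mono _ HD)].
Qed.

Definition bderiv_from_finite {Sg} (G D : sset Sg) : Prop :=
  exists G' D', finite G' /\ finite D' /\ subset G' G /\ subset D' D /\ bderiv Sg G' D'.

Lemma subset_add (Sg : sig) (D D' : sset Sg) P : subset D' D -> subset (add P D') (add P D).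
Proof. intros H phi [->|Hp]; [left|right; apply H]; auto. Qed.

Lemma bderiv_from_finite_list Sg (G D : sset Sg) (Ps : list (sentence Sg)) :
  (forall P, In P Ps -> bderiv_from_finite G (add P D)) ->
  exists G' D', finite G' /\ finite D' /\ subset G' G /\ subset D' D /\
    forall P, In P Ps -> bderiv Sg G' (add P D').
Proof.
  induction Ps as [|P Ps IH]; intros H.
  - exists emptyset, emptyset.
    repeat split; [apply finite_emptyset|apply finite_emptyset|intros ? []|intros ? []|intros ? []].
  - destruct (H P (or_introl eq_refl)) as [G1 [D1 [fG1 [fD1 [sG1 [sD1 d1]]]]]].
    destruct IH as [G2 [D2 [fG2 [fD2 [sG2 [sD2 d2]]]]]]; [intros; apply H; right; assumption|].
    exists (cup G1 G2), (cup (inter D1 D) D2).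
    repeat split; [apply finite_cup; auto|apply finite_cup; [apply finite_inter|]; auto| | |].
    + intros phi [Hp|Hp]; auto.
    + intros phi [[_ Hp]|Hp]; auto.
    + intros Q [<-|HQ]; [apply (bderiv_weak _ _ _ d1)|apply (bderiv_weak _ _ _ (d2 Q HQ))].
      * intros phi Hp. left. exact Hp.
      * intros phi Hp. destruct (sD1 phi Hp) as [->|HD]; [left; reflexivity|right; left; split; auto].
      * intros phi Hp. right. exact Hp.
      * intros phi [->|Hp]; [left; reflexivity|right; right; exact Hp].
Qed.

Ltac bderiv_core Ps P :=
  let G' := fresh "G" in let D' := fresh "D" in let d := fresh "d" in
  lazymatch goal with |- bderiv_from_finite ?G (add _ ?D) =>
    destruct (bderiv_from_finite_list _ G D Ps) as [G' [D' [? [? [? [? d]]]]]] end;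
  [let HP := fresh in intros ? HP; repeat (destruct HP as [<-|HP]; [assumption|]); destruct HP|];
  exists G', (add P D'); repeat split; [assumption|apply finite_add; assumption|assumption
                                       |apply subset_add; assumption|].

Lemma bderiv_finitary Sg G D : bderiv Sg G D -> bderiv_from_finite G D.
Proof.
  induction 1.
  - exists (add phi emptyset), (add phi emptyset).
    repeat split; [apply finite_add, finite_emptyset|apply finite_add, finite_emptyset| | |apply b_init];
      intros p [->|[]]; left; reflexivity.
  - exists emptyset, (add (sEq t t) emptyset).
    repeat split; [apply finite_emptyset|apply finite_add, finite_emptyset|intros ? []| |apply b_refl].
    intros p [->|[]]. left. reflexivity.
  - bderiv_core [sEq t t'] (sEq t' t). apply b_sym, d. left. reflexivity.
  - bderiv_core [sEq t1 t2; sEq t2 t3] (sEq t1 t3). apply b_trans with t2; apply d; simpl; auto.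
  - destruct (argpair_list Sg w ts ts') as [L HL].
    destruct (bderiv_from_finite_list _ G D (map (fun p => sEq (fst (projT2 p)) (snd (projT2 p))) L))
      as [G' [D' [? [? [? [? d]]]]]].
    { intros P HP. apply in_map_iff in HP as [[s' [u u']] [<- Hp]]. apply HL in Hp. exact (H0 _ _ _ Hp). }
    exists G', (add (sEq (app f ts) (app f ts')) D').
    repeat split; [assumption|apply finite_add; assumption|assumption|apply subset_add; assumption|].
    apply b_cong. intros s' u u' Hp. apply HL in Hp.
    exact (d _ (in_map (fun p => sEq (fst (projT2 p)) (snd (projT2 p))) _ _ Hp)).
  - bderiv_core [sEq t0 t0'; sEq t1 t1'; sTr (alab l) t0 t1] (sTr (alab l) t0' t1').
    apply b_repl with t0 t1; apply d; simpl; auto.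
Qed.

Lemma finite_choice {A B : Type} (b0 : B) (l : list A) (P : nat -> A -> B -> Prop) :
  (forall k a, nth_error l k = Some a -> exists b, P k a b) ->
  exists f : nat -> B, forall k a, nth_error l k = Some a -> P k a (f k).
Proof.
  revert P. induction l as [|a l IH]; intros P H.
  - exists (fun _ => b0). intros [|k] x E; discriminate.
  - destruct (H 0 a eq_refl) as [b Hb], (IH (fun k => P (S k)) (fun k => H (S k))) as [f Hf].
    exists (fun k => match k with 0 => b | S k' => f k' end). intros [|k] x E; [injection E as <-|]; auto.
Qed.

(* The lower bounds [Gx] and [Dx] are what lets the induction keep the principal sentences of a rule
   inside the finite sides it finds for the premises. *)
Definition derivable_from_finite {Sg} (G D : sset Sg) : Prop :=
  forall Gx Dx, finite Gx -> finite Dx -> subset Gx G -> subset Dx D ->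
  exists G' D', finite G' /\ finite D' /\ subset Gx G' /\ subset G' G /\ subset Dx D' /\ subset D' D /\
    deriv Sg G' D'.

Ltac solve_finite :=
  repeat (apply finite_add || apply finite_cup || apply finite_up || apply finite_up_inv ||
          apply finite_inter || apply finite_emptyset); auto.
(* Marks that [x \in B] has already been derived from a hypothesis [subset A B], so that the
   forward chaining in [chain_subsets] terminates. *)
Definition chained (P : Prop) : Prop := True.

Ltac split_membership := repeat match goal with
  | H : add _ _ _ |- _ => destruct H as [H|H]; [subst|]
  | H : cup _ _ _ |- _ => destruct H as [H|H]
  | H : inter _ _ _ |- _ => destruct H
  | H : up_inv _ _ _ _ |- _ => destruct H
  | H : up _ _ _ |- _ => let p := fresh "p" in destruct H as [p [? H]]; subst
  | H : emptyset _ |- _ => destruct H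
  end.
Ltac chain_subsets := repeat match goal with
  | S : subset ?A ?B, H : ?A ?x |- _ => lazymatch goal with _ : chained (B x) |- _ => fail
      | _ => assert (chained (B x)) by exact I; pose proof (S x H); split_membership end
  end.
Ltac prove_membership n := lazymatch n with
  | 0 => fail
  | S ?m => first [ assumption
         | lazymatch goal with |- add _ _ _ => first [left; reflexivity | right; prove_membership m] end
         | lazymatch goal with |- cup _ _ _ => first [left; prove_membership m | right; prove_membership m] end
         | lazymatch goal with |- inter _ _ _ => split; prove_membership m end
         | lazymatch goal with |- up_inv _ _ _ _ => split; prove_membership m end
         | lazymatch goal with |- up _ _ (trs ?p _ _) => exists p; split; [prove_membership m|reflexivity] end
         | match goal with S : subset ?A ?B |- ?B ?x => apply S; prove_membership m end ] end.
Ltac solve_subset :=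
  let x := fresh "x" in let Hx := fresh "Hx" in
  intros x Hx; split_membership; chain_subsets; prove_membership 10.
Ltac split7 := split; [|split; [|split; [|split; [|split; [|split]]]]].
Ltac conclude G' D' :=
  exists G', D'; split7; [solve_finite|solve_finite|solve_subset|solve_subset|solve_subset|solve_subset|].
Ltac reshape lo up d :=
  first [ rewrite (add2_up_eq lo up) in d | rewrite (add_up_eq lo up) in d
        | rewrite (up_up_inv_eq up) in d | rewrite (add_inter_eq lo up) in d | idtac ].

(* Applies an induction hypothesis to the given lower bounds and rewrites the sides it returns into
   the shape of the premise, e.g. [G'] into [add a (inter G' G0)] when the premise side is [add a G0]. *)
Ltac apply_IH IH Gx Dx G' D' d :=
  let fG := fresh "f" in let fD := fresh "f" in
  let loG := fresh "s" in let upG := fresh "s" in let loD := fresh "s" in let upD := fresh "s" in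
  destruct (IH Gx Dx) as [G' [D' [fG [fD [loG [upG [loD [upD d]]]]]]]];
    [solve_finite|solve_finite|solve_subset|solve_subset|];
  reshape loG upG d; reshape loD upD d.

Lemma deriv_finitary Sg G D : deriv Sg G D -> derivable_from_finite G D.
Proof.
  intros H. induction H; intros Gx Dx fGx fDx sGx sDx.
  - destruct (bderiv_finitary _ _ _ H1) as [Gb' [Db' [f1 [f2 [s1 [s2 d]]]]]].
    conclude (cup Gb' Gx) (cup Dx Db').
    apply d_atom; auto; intros p Hp; [apply H|apply H0]; auto.
  - conclude (add (sTr (azero s) t0 t1) Gx) Dx. apply d_zero.
  - apply_IH IHderiv1 (add (sTr a0 t0 t1) (inter Gx G0)) (inter Dx D0) G2 D2 d1.
    apply_IH IHderiv2 (add (sTr a1 t0 t1) (inter Gx G1)) (inter Dx D1) G3 D3 d2.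
    conclude (add (sTr (aunion a0 a1) t0 t1) (cup (inter G2 G0) (inter G3 G1))) (cup D2 D3).
    apply d_unionL; auto.
  - apply_IH IHderiv Gx (add (sTr a0 t0 t1) (inter Dx D)) G2 D2 d1.
    conclude G2 (add (sTr (aunion a0 a1) t0 t1) (inter D2 D)). apply d_unionR0; auto.
  - apply_IH IHderiv Gx (add (sTr a1 t0 t1) (inter Dx D)) G2 D2 d1.
    conclude G2 (add (sTr (aunion a0 a1) t0 t1) (inter D2 D)). apply d_unionR1; auto.
  - apply_IH IHderiv1 (inter Gx G0) (add (sTr a0 t0 t1) (inter Dx D0)) G2 D2 d1.
    apply_IH IHderiv2 (add (sTr a1 t0 t1) (inter Gx G1)) (inter Dx D1) G3 D3 d2.
    conclude (add (sTr (aimp a0 a1) t0 t1) (cup G2 (inter G3 G1))) (cup (inter D2 D0) D3).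
    apply d_aimpL; auto.
  - apply_IH IHderiv (add (sTr a0 t0 t1) (inter Gx G)) (add (sTr a1 t0 t1) (inter Dx D)) G2 D2 d1.
    conclude (inter G2 G) (add (sTr (aimp a0 a1) t0 t1) (inter D2 D)). apply d_aimpR; auto.
  - apply_IH IHderiv (add (sEq t0 t1) (inter Gx G)) Dx G2 D2 d1.
    conclude (add (sTr (aone s) t0 t1) (inter G2 G)) D2. apply d_oneL; auto.
  - apply_IH IHderiv Gx (add (sEq t0 t1) (inter Dx D)) G2 D2 d1.
    conclude G2 (add (sTr (aone s) t0 t1) (inter D2 D)). apply d_oneR; auto.
  - apply_IH IHderiv (add (sTr (EA (b1 s) a0) (E (b1 s) t0) (vx1 s))
      (add (sTr (EA (b1 s) a1) (vx1 s) (E (b1 s) t1)) (up (b1 s) (inter Gx G))))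
      (up (b1 s) Dx) G2 D2 d1.
    conclude (add (sTr (aseq a0 a1) t0 t1) (up_inv (b1 s) G G2)) (up_inv (b1 s) D D2).
    apply d_seqL; auto.
  - apply_IH IHderiv1 (inter Gx G) (add (sTr a0 t0 t) (inter Dx D)) G2 D2 d1.
    apply_IH IHderiv2 (inter Gx G') (add (sTr a1 t t1) (inter Dx D')) G3 D3 d2.
    conclude (cup G2 G3) (add (sTr (aseq a0 a1) t0 t1) (cup (inter D2 D) (inter D3 D'))).
    apply d_seqR with (t := t); auto.
  - apply_IH IHderiv (add (sTr (EA (b1 s) a0) (vx1 s) (E (b1 s) t0))
      (add (sTr (EA (b1 s) a1) (vx1 s) (E (b1 s) t1)) (up (b1 s) (inter Gx G))))
      (up (b1 s) Dx) G2 D2 d1.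
    conclude (add (sTr (arel a0 a1) t0 t1) (up_inv (b1 s) G G2)) (up_inv (b1 s) D D2).
    apply d_relL; auto.
  - apply_IH IHderiv1 (inter Gx G) (add (sTr a0 t t0) (inter Dx D)) G2 D2 d1.
    apply_IH IHderiv2 (inter Gx G') (add (sTr a1 t t1) (inter Dx D')) G3 D3 d2.
    conclude (cup G2 G3) (add (sTr (arel a0 a1) t0 t1) (cup (inter D2 D) (inter D3 D'))).
    apply d_relR with (t := t); auto.
  - apply_IH IHderiv1 (inter Gx G0) (add phi (inter Dx D0)) G2 D2 d1.
    apply_IH IHderiv2 (add psi (inter Gx G1)) (inter Dx D1) G3 D3 d2.
    conclude (add (sImp phi psi) (cup G2 (inter G3 G1))) (cup (inter D2 D0) D3). apply d_impL; auto.
  - apply_IH IHderiv (add phi (inter Gx G)) (add psi (inter Dx D)) G2 D2 d1.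
    conclude (inter G2 G) (add (sImp phi psi) (inter D2 D)). apply d_impR; auto.
  - destruct (finite_choice (emptyset, emptyset) Phi (fun k phi p =>
      finite (fst p) /\ finite (snd p) /\ subset (inter Gx (GF k)) (fst p) /\ subset (fst p) (GF k) /\
      subset (inter Dx (DF k)) (snd p) /\ subset (snd p) (DF k) /\ deriv Sg (add phi (fst p)) (snd p)))
      as [f Hf].
    { intros k phi Ek.
      apply_IH (H0 k phi Ek) (add phi (inter Gx (GF k))) (inter Dx (DF k)) G2 D2 d1.
      exists (inter G2 (GF k), D2). simpl. split7; [solve_finite|auto|solve_subset|solve_subset|auto..]. }
    exists (add (sOr Phi) (bigcup Phi (fun k => fst (f k)))), (bigcup Phi (fun k => snd (f k))).
    split7.
    + apply finite_add, finite_bigcup. intros k phi Ek. apply (Hf k phi Ek).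
    + apply finite_bigcup. intros k phi Ek. apply (Hf k phi Ek).
    + intros x Hx.
      destruct (sGx x Hx) as [E|[k [phi [Ek Hg]]]]; [left; auto|right; exists k, phi; split; auto].
      apply (Hf k phi Ek). split; auto.
    + intros x [E|[k [phi [Ek Hg]]]]; [left; auto|right; exists k, phi; split; auto].
      apply (Hf k phi Ek). auto.
    + intros x Hx. destruct (sDx x Hx) as [k [phi [Ek Hg]]]. exists k, phi; split; auto.
      apply (Hf k phi Ek). split; auto.
    + intros x [k [phi [Ek Hg]]]. exists k, phi; split; auto. apply (Hf k phi Ek). auto.
    + apply d_orL. intros k phi Ek. apply (Hf k phi Ek).
  - apply_IH IHderiv Gx (add phi (inter Dx D)) G2 D2 d1.
    conclude G2 (add (sOr Phi) (inter D2 D)). apply d_orR with phi; auto.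
  - apply_IH IHderiv (add phi (inter Gx G)) Dx G2 D2 d1.
    conclude (add (sAnd Phi) (inter G2 G)) D2. apply d_andL with phi; auto.
  - destruct (finite_choice (emptyset, emptyset) Phi (fun k phi p =>
      finite (fst p) /\ finite (snd p) /\ subset (inter Gx (GF k)) (fst p) /\ subset (fst p) (GF k) /\
      subset (inter Dx (DF k)) (snd p) /\ subset (snd p) (DF k) /\ deriv Sg (fst p) (add phi (snd p))))
      as [f Hf].
    { intros k phi Ek.
      apply_IH (H0 k phi Ek) (inter Gx (GF k)) (add phi (inter Dx (DF k))) G2 D2 d1.
      exists (G2, inter D2 (DF k)). simpl. split7; [auto|solve_finite|auto|auto|solve_subset|solve_subset|auto]. }
    exists (bigcup Phi (fun k => fst (f k))), (add (sAnd Phi) (bigcup Phi (fun k => snd (f k)))).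
    split7.
    + apply finite_bigcup. intros k phi Ek. apply (Hf k phi Ek).
    + apply finite_add, finite_bigcup. intros k phi Ek. apply (Hf k phi Ek).
    + intros x Hx. destruct (sGx x Hx) as [k [phi [Ek Hg]]]. exists k, phi; split; auto.
      apply (Hf k phi Ek). split; auto.
    + intros x [k [phi [Ek Hg]]]. exists k, phi; split; auto. apply (Hf k phi Ek). auto.
    + intros x Hx.
      destruct (sDx x Hx) as [E|[k [phi [Ek Hg]]]]; [left; auto|right; exists k, phi; split; auto].
      apply (Hf k phi Ek). split; auto.
    + intros x [E|[k [phi [Ek Hg]]]]; [left; auto|right; exists k, phi; split; auto].
      apply (Hf k phi Ek). auto.
    + apply d_andR. intros k phi Ek. apply (Hf k phi Ek).
  - apply_IH IHderiv (add phi (up X (inter Gx G))) (up X Dx) G2 D2 d1.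
    conclude (add (sEx X phi) (up_inv X G G2)) (up_inv X D D2). apply d_exL; auto.
  - apply_IH IHderiv Gx (add (inst th phi) (inter Dx D)) G2 D2 d1.
    conclude G2 (add (sEx X phi) (inter D2 D)). eapply d_exR; eauto.
  - apply_IH IHderiv (add (inst th phi) (inter Gx G)) Dx G2 D2 d1.
    conclude (add (sAll X phi) (inter G2 G)) D2. eapply d_allL; eauto.
  - apply_IH IHderiv (up X (inter Gx G)) (add phi (up X (inter Dx D))) G2 D2 d1.
    conclude (up_inv X G G2) (add (sAll X phi) (up_inv X D D2)). apply d_allR; auto.
  -
    conclude (add (sTr (astar a) t0 t1) Gx) (add (sTr (astar a) t0 t1) Dx). apply d_starAx.
  - apply_IH IHderiv1 (inter Gx G0) (add (sTr (astar a) t0 t1) (inter Dx D0)) G2 D2 d1.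
    apply_IH IHderiv2 (add (sTr (astar a) t0 t1) (inter Gx G1)) (inter Dx D1) G3 D3 d2.
    conclude (cup G2 (inter G3 G1)) (cup (inter D2 D0) D3). eapply d_starCut; eauto.
  - apply_IH IHderiv Gx (add (sEq t0 t1) (inter Dx D)) G2 D2 d1.
    conclude G2 (add (sTr (astar a) t0 t1) (inter D2 D)). apply d_starR0; auto.
  - apply_IH IHderiv1 (inter Gx G) (add (sTr (astar a) t0 t) (inter Dx D)) G2 D2 d1.
    apply_IH IHderiv2 (inter Gx G') (add (sTr a t t1) (inter Dx D')) G3 D3 d2.
    conclude (cup G2 G3) (add (sTr (astar a) t0 t1) (cup (inter D2 D) (inter D3 D'))).
    apply d_starR1 with (t := t); auto.
  - apply_IH IHderiv1 (inter Gx G) (add (sTr a t0 t) (inter Dx D)) G2 D2 d1.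
    apply_IH IHderiv2 (inter Gx G') (add (sTr (astar a) t t1) (inter Dx D')) G3 D3 d2.
    conclude (cup G2 G3) (add (sTr (astar a) t0 t1) (cup (inter D2 D) (inter D3 D'))).
    apply d_starR2 with (t := t); auto.
  - apply_IH IHderiv1 (inter Gx GL) (add (sTr tt t t0) (inter Dx DL)) G2 D2 d1.
    apply_IH IHderiv2 (add (sTr (EA (b3 s) tt) (vz s) (vx s))
      (add (sTr (EA (b3 s) a) (vx s) (vy s)) (up (b3 s) (inter Gx GM))))
      (add (sTr (EA (b3 s) tt) (vz s) (vy s)) (up (b3 s) (inter Dx DM))) G3 D3 d2.
    apply_IH IHderiv3 (add (sTr tt t t1) (inter Gx GR)) (inter Dx DR) G4 D4 d3.
    conclude (add (sTr (astar a) t0 t1) (cup G2 (cup (up_inv (b3 s) GM G3) (inter G4 GR))))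
      (cup (inter D2 DL) (cup (up_inv (b3 s) DM D3) D4)).
    eapply d_starIndL; eauto.
  - apply_IH IHderiv1 (inter Gx GL) (add (sTr tt t1 t) (inter Dx DL)) G2 D2 d1.
    apply_IH IHderiv2 (add (sTr (EA (b3 s) a) (vx s) (vy s))
      (add (sTr (EA (b3 s) tt) (vy s) (vz s)) (up (b3 s) (inter Gx GM))))
      (add (sTr (EA (b3 s) tt) (vx s) (vz s)) (up (b3 s) (inter Dx DM))) G3 D3 d2.
    apply_IH IHderiv3 (add (sTr tt t0 t) (inter Gx GR)) (inter Dx DR) G4 D4 d3.
    conclude (add (sTr (astar a) t0 t1) (cup G2 (cup (up_inv (b3 s) GM G3) (inter G4 GR))))
      (cup (inter D2 DL) (cup (up_inv (b3 s) DM D3) D4)).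
    eapply d_starIndR; eauto.
Qed.

Corollary deriv_finite_sides (Sg : sig) (G D : sset Sg) :
  deriv Sg G D ->
  exists LG LD : list (sentence Sg), (forall phi, In phi LG -> G phi) /\ (forall phi, In phi LD -> D phi) /\
    deriv Sg (fun phi => In phi LG) (fun phi => In phi LD).
Proof.
  intros H.
  destruct (deriv_finitary _ _ _ H emptyset emptyset (finite_emptyset _) (finite_emptyset _)
              (fun _ x => match x with end) (fun _ x => match x with end))
    as [G' [D' [[LG HLG] [[LD HLD] [_ [HG [_ [HD Hd]]]]]]]].
  exists LG, LD. split; [intros phi Hp; apply HG, HLG, Hp|]. split; [intros phi Hp; apply HD, HLD, Hp|].
  replace (fun phi => In phi LG) with G' by (apply sset_ext; intros; rewrite HLG; reflexivity).
  replace (fun phi => In phi LD) with D' by (apply sset_ext; intros; rewrite HLD; reflexivity).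
  exact Hd.
Qed.

(** * Compactness *)

Definition sorts_of {Sg} (K : list (symbol Sg)) : list (srt Sg) :=
  flat_map (fun y => match y with ySort s => [s] | @yFun _ w s f => s :: w | @yLab _ s l => [s] end) K.

Definition subsig {Sg} (K : list (symbol Sg)) : sig :=
  {| srt := {s : srt Sg | In s (sorts_of K)};
     fsym := fun w s => {f : fsym Sg (map (@proj1_sig _ _) w) (proj1_sig s) | In (yFun f) K};
     lab := fun s => {l : lab Sg (proj1_sig s) | In (yLab l) K} |}.

Definition subsig_incl {Sg} (K : list (symbol Sg)) : sigmor (subsig K) Sg :=
  SigMor (subsig K) Sg (@proj1_sig _ _) (fun w s f => proj1_sig f) (fun s l => proj1_sig l).

Lemma sig_eq (A : Type) (P : A -> Prop) (x y : {a | P a}) : proj1_sig x = proj1_sig y -> x = y.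
Proof. destruct x, y. simpl. intros ->. f_equal. apply proof_irrelevance. Qed.

Lemma subsig_incl_injective (Sg : sig) (K : list (symbol Sg)) : injective_sigmor (subsig_incl K).
Proof. split; [|split]; intros; apply sig_eq; assumption. Qed.

Lemma map_proj1_sig_surj (A : Type) (P : A -> Prop) (w : list A) :
  (forall x, In x w -> P x) -> exists w' : list {a | P a}, map (@proj1_sig _ _) w' = w.
Proof.
  induction w as [|a w IH]; intros H; [exists []; reflexivity|].
  destruct IH as [w' E]; [intros; apply H; right; assumption|].
  exists (exist _ a (H a (or_introl eq_refl)) :: w'). simpl. congruence.
Qed.

Lemma in_sorts_of (Sg : sig) (K : list (symbol Sg)) y s :
  In y K -> In s (match y with ySort s => [s] | @yFun _ w s f => s :: w | @yLab _ s l => [s] end) ->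
  In s (sorts_of K).
Proof. intros Hy Hs. apply in_flat_map. exists y. auto. Qed.

Lemma subsig_incl_covers (Sg : sig) (K : list (symbol Sg)) : covers (subsig_incl K) K.
Proof.
  intros y Hy. pose proof (in_sorts_of _ K y) as HS. destruct y as [s|w s f|s l]; simpl in HS |- *.
  - exists (exist _ s (HS s Hy (or_introl eq_refl))). reflexivity.
  - destruct (map_proj1_sig_surj _ _ w (fun x Hx => HS x Hy (or_intror Hx))) as [w' <-].
    exists w', (exist _ s (HS s Hy (or_introl eq_refl))), (exist _ f Hy). reflexivity.
  - exists (exist _ s (HS s Hy (or_introl eq_refl))), (exist _ l Hy). reflexivity.
Qed.

Lemma listable_of_injective {T B : Type} (g : T -> B) (L : list B) :
  (forall x y, g x = g y -> x = y) -> (forall t, In (g t) L) -> exists LT : list T, forall t, In t LT.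
Proof.
  intros Hg HL.
  assert (H : forall L', exists LT : list T, forall t, In (g t) L' -> In t LT).
  { induction L' as [|b L' [LT HLT]]; [exists []; intros t []|].
    destruct (classic (exists t0, g t0 = b)) as [[t0 E]|Hn].
    - exists (t0 :: LT). intros t [Et|Ht]; [left; apply Hg; congruence|right; auto].
    - exists LT. intros t [Et|Ht]; [exfalso; eauto|auto]. }
  destruct (H L) as [LT HLT]. exists LT. auto.
Qed.

Definition symF {Sg} (y : symbol Sg) : option {w & {s & fsym Sg w s}} :=
  match y with @yFun _ w s f => Some (existT _ w (existT _ s f)) | _ => None end.

Definition symL {Sg} (y : symbol Sg) : option {s & lab Sg s} :=
  match y with @yLab _ s l => Some (existT _ s l) | _ => None end.

Lemma subsig_finite (Sg : sig) (K : list (symbol Sg)) : finite_sig (subsig K).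
Proof.
  split; [|split].
  - apply (listable_of_injective (@proj1_sig _ _) (sorts_of K)); [apply sig_eq|intros [s Hs]; exact Hs].
  - destruct (listable_of_injective (T := {w & {s & fsym (subsig K) w s}})
                (fun t => yFun (proj1_sig (projT2 (projT2 t)))) K) as [l Hl];
      [|intros [w [s [f Hf]]]; exact Hf|exists l; intros; apply Hl].
    intros [w1 [s1 f1]] [w2 [s2 f2]] E. apply (f_equal symF), Some_injective in E. simpl in E.
    pose proof (f_equal (@projT1 _ _) E) as Ew. simpl in Ew.
    apply map_injective in Ew; [subst w2|apply sig_eq]. apply inj_pair2 in E.
    pose proof (f_equal (@projT1 _ _) E) as Es. apply sig_eq in Es. subst s2. apply inj_pair2 in E.
    apply sig_eq in E. subst f2. reflexivity.
  - destruct (listable_of_injective (T := {s & lab (subsig K) s}) (fun t => yLab (proj1_sig (projT2 t))) K)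
      as [l Hl]; [|intros [s [x Hx]]; exact Hx|exists l; intros; apply Hl].
    intros [s1 l1] [s2 l2] E. apply (f_equal symL), Some_injective in E. simpl in E.
    pose proof (f_equal (@projT1 _ _) E) as Es. apply sig_eq in Es. subst s2. apply inj_pair2 in E.
    apply sig_eq in E. subst l2. reflexivity.
Qed.

Lemma preimage_map_trs (Sf Sg : sig) (i : sigmor Sf Sg) (L : list (sentence Sf)) :
  injective_sigmor i ->
  preimage i (fun phi => In phi (map (fun p => trs p Sg (mor_of i)) L)) = (fun phi => In phi L).
Proof.
  intros Hi. apply sset_ext. intros phi. unfold preimage. split.
  - apply in_map_trs_inv. exact Hi.
  - apply (in_map (fun p => trs p Sg (mor_of i))).
Qed.

Theorem deriv_compact (Sg : sig) (G D : sset Sg) :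
  deriv Sg G D ->
  exists (Sf : sig) (i : sigmor Sf Sg) (Gf Df : list (sentence Sf)),
    finite_sig Sf /\ injective_sigmor i /\
    (forall phi, In phi Gf -> G (trs phi Sg (mor_of i))) /\
    (forall phi, In phi Df -> D (trs phi Sg (mor_of i))) /\
    deriv Sf (fun phi => In phi Gf) (fun phi => In phi Df).
Proof.
  intros H.
  destruct (deriv_finite_sides _ _ _ H) as [LG [LD [HG [HD Hfin]]]].
  destruct (deriv_restrictable _ _ _ Hfin) as [K HK].
  set (K' := K ++ flat_map syms LG ++ flat_map syms LD).
  pose proof (subsig_incl_covers _ K') as HC. pose proof (subsig_incl_injective _ K') as Hi.
  apply covers_app in HC as [HCK HC]. apply covers_app in HC as [HCG HCD].
  clearbody K'. set (i := subsig_incl K') in *. clearbody i.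
  destruct (list_trs_preimage _ _ i Hi LG HCG) as [Gf EG], (list_trs_preimage _ _ i Hi LD HCD) as [Df ED].
  subst LG LD.
  exists _, i, Gf, Df. split; [apply subsig_finite|]. split; [exact Hi|]. split; [|split].
  - intros phi Hp. apply HG, (in_map (fun p => trs p Sg (mor_of i))). exact Hp.
  - intros phi Hp. apply HD, (in_map (fun p => trs p Sg (mor_of i))). exact Hp.
  - rewrite <- !(preimage_map_trs _ _ i _ Hi). exact (HK _ i Hi HCK).
Qed.

(** * Incompleteness *)

Definition Sg_succ : sig :=
  {| srt := unit;
     fsym := fun w s => match w with [] => bool | _ :: _ => Empty_set end;
     lab := fun _ => unit |}.

Definition const (b : bool) : term Sg_succ tt := @app Sg_succ [] tt b tnil.
Definition succ : action Sg_succ tt := @alab Sg_succ tt tt.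

Fixpoint succ_pow (n : nat) : action Sg_succ tt :=
  match n with 0 => @aone Sg_succ tt | S n => aseq succ (succ_pow n) end.

Definition reach_false : sentence Sg_succ := sTr (astar succ) (const true) (const false).

Definition not_reach_false_in (n : nat) : sentence Sg_succ :=
  sImp (sTr (succ_pow n) (const true) (const false)) (sOr []).

Definition Gamma_omega : sset Sg_succ := fun phi => phi = reach_false \/ exists n, phi = not_reach_false_in n.

Definition Delta_empty : sset Sg_succ := fun _ => False.

Lemma succ_pow_add (M : model Sg_succ) n m x y z :
  aden M (succ_pow n) x y -> aden M (succ_pow m) y z -> aden M (succ_pow (n + m)) x z.
Proof.
  revert x. induction n as [|n IH]; intros x H1 H2; simpl in *.
  - subst. exact H2.
  - destruct H1 as [u [H1 H3]]. exists u. split; [exact H1|]. eapply IH; eauto.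
Qed.

Lemma rt_succ_pow (M : model Sg_succ) x y :
  clos_refl_trans _ (aden M succ) x y -> exists n, aden M (succ_pow n) x y.
Proof.
  induction 1 as [x y H| |x y z _ [n1 H1] _ [n2 H2]].
  - exists 1. exists y. simpl. auto.
  - exists 0. reflexivity.
  - exists (n1 + n2). eapply succ_pow_add; eauto.
Qed.

Lemma omega_valid : valid Sg_succ Gamma_omega Delta_empty.
Proof.
  intros M HM. exfalso. destruct (rt_succ_pow _ _ _ (HM reach_false (or_introl eq_refl))) as [n Hn].
  exact (HM (not_reach_false_in n) (or_intror (ex_intro _ n eq_refl)) Hn).
Qed.

(* [true] is [0], [false] is [N] and [succ] is the successor, so that exactly the sentences
   [not_reach_false_in n] with [n <> N] hold. *)
Definition model_upto (N : nat) : model Sg_succ :=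
  Model Sg_succ (fun _ => nat)
    (fun w s => match w return fsym Sg_succ w s -> tuple (fun _ => nat) w -> nat with
                | [] => fun b _ => if b then 0 else N
                | _ :: _ => fun e => match e with end end)
    (fun s l x y => y = S x).

Lemma aden_succ_pow N n x y : aden (model_upto N) (succ_pow n) x y <-> y = n + x.
Proof.
  revert x. induction n as [|n IH]; intros x; simpl.
  - split; intros; subst; reflexivity.
  - split.
    + intros [u [-> H2]]. apply IH in H2. lia.
    + intros E. exists (S x). split; [reflexivity|]. apply IH. lia.
Qed.

Lemma sat_model_upto N phi :
  phi = reach_false \/ (exists n, n < N /\ phi = not_reach_false_in n) -> sat phi (model_upto N).
Proof.
  intros [->|[n [Hn ->]]]; simpl.
  - induction N; [apply rt_refl|]. eapply rt_trans; [exact IHN|]. apply rt_step. reflexivity.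
  - intros H. apply aden_succ_pow in H. simpl in H. lia.
Qed.

Lemma Gamma_omega_finite_bound (L : list (sentence Sg_succ)) :
  (forall phi, In phi L -> Gamma_omega phi) ->
  exists N, forall phi, In phi L -> phi = reach_false \/ exists n, n < N /\ phi = not_reach_false_in n.
Proof.
  induction L as [|a L IH]; intros H; [exists 0; intros ? []|].
  destruct IH as [N HN]; [intros; apply H; right; assumption|].
  destruct (H a (or_introl eq_refl)) as [->|[n ->]].
  - exists N. intros phi [<-|Hp]; auto.
  - exists (S (N + n)). intros phi [<-|Hp].
    + right. exists n. split; [lia|reflexivity].
    + destruct (HN phi Hp) as [E|[m [Hm E]]]; [auto|right; exists m; split; [lia|exact E]].
Qed.

Lemma omega_not_derivable : ~ deriv Sg_succ Gamma_omega Delta_empty.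
Proof.
  intros Hd. destruct (deriv_compact _ _ _ Hd) as [Sf [i [Gf [Df [_ [_ [HG [HD Hder]]]]]]]].
  destruct (Gamma_omega_finite_bound (map (fun p => trs p _ (mor_of i)) Gf)) as [N HN].
  { intros phi Hp. apply in_map_iff in Hp as [p [<- Hp]]. exact (HG p Hp). }
  destruct (deriv_sound _ _ _ Hder (reduct (mor_of i) (model_upto N))) as [psi [Hpsi _]].
  - intros phi Hp. apply sat_trs, sat_model_upto, HN, (in_map (fun p => trs p _ (mor_of i))), Hp.
  - exact (HD psi Hpsi).
Qed.

Theorem lemma22 :
  (* soundness *)
  (forall (Sg : sig) (G D : sset Sg), deriv Sg G D -> valid Sg G D) /\
  (* incompleteness *)
  (exists (Sg : sig) (G D : sset Sg), valid Sg G D /\ ~ deriv Sg G D) /\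
  (* compactness *)
  (forall (Sg : sig) (G D : sset Sg), deriv Sg G D ->
     exists (Sf : sig) (i : sigmor Sf Sg) (Gf Df : list (sentence Sf)),
       finite_sig Sf /\ injective_sigmor i /\
       (forall phi, In phi Gf -> G (trs phi Sg (mor_of i))) /\
       (forall phi, In phi Df -> D (trs phi Sg (mor_of i))) /\
       deriv Sf (fun phi => In phi Gf) (fun phi => In phi Df)).
Proof.
  split; [exact deriv_sound|]. split; [|exact deriv_compact].
  exists Sg_succ, Gamma_omega, Delta_empty. split; [exact omega_valid|exact omega_not_derivable].
Qed.
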